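(* For every word $C$ over the alphabet $\Sigma_D$ there exists a word $C'$ over $\Sigma_D$ in which the total number of occurrences of the symbols $CCX_{0,1}$, $CCX_{0,2}$, $CCX_{1,2}$ (the Toffoli count of $C'$) is at most $120$, and such that $[\![C]\!] = [\![C']\!]$.
   Context: Qubits are labelled $0,1,2$. The computational basis vector $|x_0x_1x_2\rangle$ ($x_i\in\{0,1\}$) is identified with the standard basis vector $e_{4x_0+2x_1+x_2}$ of $\mathbb{R}^8$, so a $2\times 2$ matrix $M$ acting on qubit $0$, $1$, $2$ is $M\otimes I\otimes I$, $I\otimes M\otimes I$, $I\otimes I\otimes M$ respectively, written $M_j$. Let $X=\begin{bmatrix}0&1\\1&0\end{bmatrix}$, $Z=\begin{bmatrix}1&0\\0&-1\end{bmatrix}$, $H=\frac{1}{\sqrt2}\begin{bmatrix}1&1\\1&-1\end{bmatrix}$. For $j\neq k$, $CX_{j,k}$ (resp. $CZ_{j,k}$) is the $8\times 8$ matrix sending $|x_0x_1x_2\rangle$ to $(X_k)^{x_j}|x_0x_1x_2\rangle$ (resp. $(Z_k)^{x_j}|x_0x_1x_2\rangle$). For $j<k$, $CCX_{j,k}$ sends $|x_0x_1x_2\rangle$ to $(X_l)^{x_jx_k}|x_0x_1x_2\rangle$ where $l$ is the element of $\{0,1,2\}\setminus\{j,k\}$. $K_{j,k}=H_jH_k$, and $\sigma_{j,k}$ is the permutation matrix swapping qubits $j$ and $k$. The alphabet $\Sigma_D$ consists of the $23$ symbols $X_0,X_1,X_2$; $CX_{k,l}$ for all $k\neq l$ in $\{0,1,2\}$;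 $CCX_{0,1},CCX_{0,2},CCX_{1,2}$; $Z_0,Z_1,Z_2$; $CZ_{0,1},CZ_{0,2},CZ_{1,2}$; $K_{0,1},K_{1,2}$; $\sigma_{0,1},\sigma_{0,2},\sigma_{1,2}$, each interpreted as the corresponding $8\times 8$ matrix. A word $w_1w_2\cdots w_m$ over $\Sigma_D$ is interpreted as the matrix product $[\![w_1w_2\cdots w_m]\!]=[\![w_1]\!][\![w_2]\!]\cdots[\![w_m]\!]$ (the empty word gives the identity). *)

From HB Require Import structures.
From mathcomp Require Import all_boot all_order all_algebra.
From mathcomp Require Import reals.
Set Implicit Arguments. Unset Strict Implicit. Unset Printing Implicit Defensive.
Import Order.TTheory GRing.Theory Num.Theory.
Local Open Scope ring_scope.

(* Basis index x : 'I_8 encodes |x0 x1 x2> with x = 4 x0 + 2 x1 + x2. *)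
Definition bit (j : 'I_3) (x : 'I_8) : bool := odd (x %/ 2 ^ (2 - j)).

Definition b2o (b : bool) : 'I_2 := inord (nat_of_bool b).

Definition mkidx (b : 'I_3 -> bool) : 'I_8 :=
  inord (4 * b (@inord 2 0) + 2 * b (@inord 2 1) + b (@inord 2 2)).

Section Gates.
Variable R : realType.

(* M_j = M acting on qubit j (tensor product with identities), entrywise *)
Definition one_q (M : 'M[R]_2) (j : 'I_3) : 'M[R]_8 :=
  \matrix_(x, y) if [forall k : 'I_3, (k != j) ==> (bit k x == bit k y)]
                 then M (b2o (bit j x)) (b2o (bit j y)) else 0.

Definition Xm : 'M[R]_2 := \matrix_(i, j) if i == j then 0 else 1.
Definition Zm : 'M[R]_2 := \matrix_(i, j) if i == j then (if i == 1 then -1 else 1) else 0.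
Definition Hm : 'M[R]_2 :=
  (Num.sqrt (2 : R))^-1 *: \matrix_(i, j) (if (i == 1) && (j == 1) then -1 else 1).

(* column y of the matrix is the image of e_y *)
(* |x> |-> U^{x_j} |x> *)
Definition ctrl (j : 'I_3) (U : 'M[R]_8) : 'M[R]_8 :=
  \matrix_(x, y) if bit j y then U x y else (x == y)%:R.
(* |x> |-> U^{x_j x_k} |x> *)
Definition ctrl2 (j k : 'I_3) (U : 'M[R]_8) : 'M[R]_8 :=
  \matrix_(x, y) if bit j y && bit k y then U x y else (x == y)%:R.

Definition swap_idx (j k : 'I_3) (x : 'I_8) : 'I_8 :=
  mkidx (fun i => bit (if i == j then k else if i == k then j else i) x).
Definition sigma (j k : 'I_3) : 'M[R]_8 :=
  \matrix_(x, y) (x == swap_idx j k y)%:R.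

End Gates.

Notation q0 := (@Ordinal 3 0 isT).
Notation q1 := (@Ordinal 3 1 isT).
Notation q2 := (@Ordinal 3 2 isT).

Inductive sym : Type :=
| sX0 | sX1 | sX2
| sCX01 | sCX02 | sCX10 | sCX12 | sCX20 | sCX21
| sCCX01 | sCCX02 | sCCX12
| sZ0 | sZ1 | sZ2
| sCZ01 | sCZ02 | sCZ12
| sK01 | sK12
| sS01 | sS02 | sS12.

Definition sem (R : realType) (s : sym) : 'M[R]_8 :=
  match s with
  | sX0 => one_q (Xm R) q0 | sX1 => one_q (Xm R) q1 | sX2 => one_q (Xm R) q2
  | sCX01 => ctrl q0 (one_q (Xm R) q1) | sCX02 => ctrl q0 (one_q (Xm R) q2)
  | sCX10 => ctrl q1 (one_q (Xm R) q0) | sCX12 => ctrl q1 (one_q (Xm R) q2)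
  | sCX20 => ctrl q2 (one_q (Xm R) q0) | sCX21 => ctrl q2 (one_q (Xm R) q1)
  | sCCX01 => ctrl2 q0 q1 (one_q (Xm R) q2)
  | sCCX02 => ctrl2 q0 q2 (one_q (Xm R) q1)
  | sCCX12 => ctrl2 q1 q2 (one_q (Xm R) q0)
  | sZ0 => one_q (Zm R) q0 | sZ1 => one_q (Zm R) q1 | sZ2 => one_q (Zm R) q2
  | sCZ01 => ctrl q0 (one_q (Zm R) q1) | sCZ02 => ctrl q0 (one_q (Zm R) q2)
  | sCZ12 => ctrl q1 (one_q (Zm R) q2)
  | sK01 => one_q (Hm R) q0 *m one_q (Hm R) q1
  | sK12 => one_q (Hm R) q1 *m one_q (Hm R) q2
  | sS01 => sigma R q0 q1 | sS02 => sigma R q0 q2 | sS12 => sigma R q1 q2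
  end.

Definition interp (R : realType) (w : seq sym) : 'M[R]_8 :=
  foldr (fun s M => sem R s *m M) 1%:M w.

Definition is_toffoli (s : sym) : bool :=
  match s with sCCX01 | sCCX02 | sCCX12 => true | _ => false end.

Definition toffoli_count (w : seq sym) : nat := count is_toffoli w.

From HB Require Import structures.
From mathcomp Require Import all_boot all_order all_algebra.
From mathcomp Require Import reals ssrZ.
From Stdlib Require Import BinInt Zdiv.
Import ssrZ.Instances.
(* importing BinInt rebinds the %N delimiter to N_scope *)
Delimit Scope nat_scope with N.
Set Implicit Arguments. Unset Strict Implicit. Unset Printing Implicit Defensive.
Import Order.TTheory GRing.Theory Num.Theory.
Local Open Scope ring_scope.

(* The group generated by the gates of Sigma_D is finite, and already generated
   by CCX_{0,1}, K_{0,1}, sigma_{0,1}, sigma_{1,2}, Z_0 and CZ_{0,1}.  A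
   stabiliser chain for its action on the basis vectors e_0, ..., e_6 gives
   transversals T_1, ..., T_7, written as explicit words, such that every
   element of the group is a product u_1 ... u_7 with u_i in T_i; bounding the
   Toffoli count of u_i by the largest one in T_i and summing gives 120.  It
   suffices that these products contain the identity and are closed under left
   multiplication by the generators, which reduces, level by level, to finitely
   many matrix identities.  They are checked by exact computation, since every
   matrix of the group is M / 4 for an integral M. *)

Section Factorization.
Variables (A : eqType) (G : pzSemiRingType) (f : A -> G).
Implicit Types (w u v : seq A) (T S : seq (seq A)) (Ts : seq (seq (seq A))).

Definition eval w : G := \prod_(a <- w) f a.

Lemma eval_cat w1 w2 : eval (w1 ++ w2) = eval w1 * eval w2.
Proof. exact: big_cat. Qed.

Lemma eval_flatten (ws : seq (seq A)) : eval (flatten ws) = \prod_(w <- ws) eval w.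
Proof.
elim: ws => [|w ws IH]; first by rewrite big_nil /eval big_nil.
by rewrite big_cons eval_cat IH.
Qed.

Fixpoint in_product Ts (x : G) : Prop :=
  if Ts is T :: Ts' then
    exists2 u, u \in T & exists2 y, in_product Ts' y & x = eval u * y
  else x = 1.

Definition stable Ts S :=
  forall v x, v \in S -> in_product Ts x -> in_product Ts (eval v * x).

Lemma stable_prod Ts S ws x : stable Ts S -> all (mem S) ws ->
  in_product Ts x -> in_product Ts ((\prod_(w <- ws) eval w) * x).
Proof.
move=> stTS; elim: ws => [|w ws IH] /= wsS Tx; first by rewrite big_nil mul1r.
case/andP: wsS => wS wsS.
by rewrite big_cons -mulrA; apply: stTS wS (IH wsS Tx).
Qed.

Definition absorbs T Ts S := forall v u, v \in S -> u \in T ->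
  exists2 u', u' \in T & exists2 ws, all (mem (flatten Ts)) ws &
    eval v * eval u = eval u' * \prod_(w <- ws) eval w.

Lemma stable_cons T Ts S :
  stable Ts (flatten Ts) -> absorbs T Ts S -> stable (T :: Ts) S.
Proof.
move=> stTs absT v _ vS [u uT [y Tsy ->]].
have [u' u'T [ws wsTs Evu]] := absT v u vS uT.
exists u' => //; exists ((\prod_(w <- ws) eval w) * y).
  exact: stable_prod stTs wsTs Tsy.
by rewrite mulrA Evu mulrA.
Qed.

Fixpoint absorbing_chain Ts : Prop :=
  if Ts is T :: Ts' then absorbs T Ts' (flatten Ts) /\ absorbing_chain Ts'
  else True.

Lemma absorbing_chain_stable Ts : absorbing_chain Ts -> stable Ts (flatten Ts).
Proof.
elim: Ts => [_ v x|T Ts IH [absT /IH stTs]]; last exact: stable_cons.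
by rewrite in_nil.
Qed.

Lemma in_product1 Ts : all (fun T => [::] \in T) Ts -> in_product Ts 1.
Proof.
elim: Ts => [//|T Ts IH /= /andP[nilT /IH Ts1]].
by exists [::] => //; exists 1; rewrite // /eval big_nil mulr1.
Qed.

Lemma in_product_eval Ts (S : seq A) w : all (fun T => [::] \in T) Ts ->
  stable Ts [seq [:: a] | a <- S] -> all (mem S) w -> in_product Ts (eval w).
Proof.
move=> Ts1 stTs; elim: w => [_|a w IH /= /andP[aS wS]].
  by rewrite /eval big_nil; exact: in_product1.
have -> : eval (a :: w) = eval [:: a] * eval w by rewrite -eval_cat.
by apply: stTs (IH wS); rewrite map_f.
Qed.

Lemma in_product_count (p : pred A) Ts x : in_product Ts x ->
  exists2 w, x = eval w & (count p w <= \sum_(T <- Ts) \max_(u <- T) count p u)%N.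
Proof.
elim: Ts x => [x ->|T Ts IH x [u uT [y /IH[w -> pw] ->]]].
  by exists [::]; rewrite /eval ?big_nil.
exists (u ++ w); first by rewrite eval_cat.
rewrite count_cat big_cons leq_add //.
by rewrite (big_rem u uT) leq_maxl.
Qed.

End Factorization.

Notation zmat := (seq (seq Z)).
Definition zget (A : zmat) (i j : nat) : Z := nth 0%Z (nth [::] A i) j.
Definition ztab (F : nat -> nat -> Z) : zmat := mkseq (fun i => mkseq (F i) 8) 8.

Fixpoint zdot (r c : seq Z) : Z :=
  if (r, c) is (x :: r', y :: c') then (x * y + zdot r' c')%Z else 0%Z.

Definition ztr (A : zmat) : zmat := ztab (fun i j => zget A j i).
Definition zmul (A B : zmat) : zmat :=
  let Bt := ztr B in map (fun r => map (zdot r) Bt) A.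
Definition zdiv4 (A : zmat) : zmat := map (map (fun x => x / 4)%Z) A.
Definition zmul4 (A B : zmat) : option zmat :=
  let P := zmul A B in
  if all (all (fun x => x mod 4 =? 0)%Z) P then Some (zdiv4 P) else None.
Definition zid4 : zmat := ztab (fun i j => if i == j then 4%Z else 0%Z).
Definition zprod4 (As : seq zmat) : option zmat :=
  foldr (fun A oB => obind (zmul4 A) oB) (Some zid4) As.

Lemma zget_tab F i j : (i < 8)%N -> (j < 8)%N -> zget (ztab F) i j = F i j.
Proof. by move=> i8 j8; rewrite /zget nth_mkseq // nth_mkseq. Qed.

Lemma zget_map (g : Z -> Z) A i j : g 0%Z = 0%Z ->
  zget (map (map g) A) i j = g (zget A i j).
Proof.
move=> g0; rewrite /zget.
have [iA|Ai] := ltnP i (size A); last first.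
  by rewrite !(nth_default [::]) ?size_map ?nth_nil.
rewrite (nth_map [::]) //.
have [jA|Aj] := ltnP j (size (nth [::] A i)); first by rewrite (nth_map 0%Z).
by rewrite !(nth_default 0%Z) ?size_map.
Qed.

Section ZMatrices.
Variable R : numFieldType.

Definition Z2R (z : Z) : R := (int_of_Z z)%:~R.

Lemma Z2R_add x y : Z2R (x + y)%Z = Z2R x + Z2R y.
Proof. by rewrite /Z2R (raddfD int_of_Z x y) intrD. Qed.

Lemma Z2R_mul x y : Z2R (x * y)%Z = Z2R x * Z2R y.
Proof. by rewrite /Z2R (rmorphM int_of_Z x y) intrM. Qed.

Definition matZ (A : zmat) : 'M[R]_8 := \matrix_(i, j) Z2R (zget A i j).

Definition zrep (A : zmat) (M : 'M[R]_8) := matZ A = 4 *: M.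

Lemma Z2R_zdot r c :
  Z2R (zdot r c) = \sum_(k < size c) Z2R (nth 0%Z r k) * Z2R (nth 0%Z c k).
Proof.
elim: c r => [|y c IH] [|x r] /=; rewrite ?big_ord0 //.
  by rewrite big1 // => k _; rewrite nth_nil mul0r.
by rewrite Z2R_add Z2R_mul IH big_ord_recl.
Qed.

Lemma matZ_mul A B : matZ (zmul A B) = matZ A *m matZ B.
Proof.
apply/matrixP=> i j; rewrite !mxE /zget /zmul.
have [iA|Ai] := ltnP i (size A); last first.
  rewrite (nth_default [::]) ?size_map // nth_nil big1 // => k _.
  by rewrite mxE /zget (nth_default [::] Ai) nth_nil mul0r.
rewrite (nth_map [::]) // (nth_map [::]) ?size_mkseq // nth_mkseq //.
rewrite Z2R_zdot size_mkseq; apply: eq_bigr => k _.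
by rewrite nth_mkseq // !mxE.
Qed.

Lemma matZ_tab F : matZ (ztab F) = \matrix_(i, j) Z2R (F i j).
Proof. by apply/matrixP=> i j; rewrite !mxE zget_tab. Qed.

Lemma zget_all (p : pred Z) A i j : p 0%Z -> all (all p) A -> p (zget A i j).
Proof.
move=> p0 /(all_nthP [::]) pA; rewrite /zget.
have [iA|Ai] := ltnP i (size A); last by rewrite (nth_default [::] Ai) nth_nil.
have /(all_nthP 0%Z) pAi := pA i iA.
by have [jA|Aj] := ltnP j (size (nth [::] A i)); [exact: pAi | rewrite nth_default].
Qed.

Lemma matZ_zdiv4 P : all (all (fun x => x mod 4 =? 0)%Z) P ->
  matZ P = 4 *: matZ (zdiv4 P).
Proof.
move=> P4; apply/matrixP=> i j; rewrite !mxE /zdiv4 zget_map //.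
have /Z.eqb_eq Pij := zget_all i j (erefl true) P4.
by rewrite {1}(Z_div_exact_full_2 _ 4 _ Pij) // Z2R_mul.
Qed.

Lemma four_neq0 : (4 : R) != 0. Proof. by rewrite pnatr_eq0. Qed.

Lemma zrep_mul A B M N C : zrep A M -> zrep B N -> zmul4 A B = Some C ->
  zrep C (M *m N).
Proof.
rewrite /zrep /zmul4 => AM BN; case: ifP => // P4 [<-].
apply: (scalerI four_neq0).
by rewrite -matZ_zdiv4 // matZ_mul AM BN -scalemxAl -scalemxAr !scalerA.
Qed.

Lemma zrep_inj A M N : zrep A M -> zrep A N -> M = N.
Proof.
by rewrite /zrep => -> /(scalerI four_neq0).
Qed.

Lemma zrep_id4 : zrep zid4 1%:M.
Proof.
rewrite /zrep /zid4 matZ_tab; apply/matrixP=> i j; rewrite !mxE -val_eqE.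
by case: eqP => _; rewrite /Z2R /= ?mulr1 ?mulr0.
Qed.

End ZMatrices.

Definition bitn (j : 'I_3) (x : nat) : bool := odd (x %/ 2 ^ (2 - j)).
Definition all_qubits (P : 'I_3 -> bool) : bool := [&& P q0, P q1 & P q2].

Lemma forall_qubitsE (P : 'I_3 -> bool) : [forall k, P k] = all_qubits P.
Proof.
apply/forallP/and3P => [P3|[P0 P1 P2] [[|[|[|k]]] k3]]; first by split; apply: P3.
all: by rewrite ?(bool_irrelevance k3 isT).
Qed.

Definition zscale (c : Z) (A : zmat) : zmat := map (map (Z.mul c)) A.

Definition one_qZ (m : bool -> bool -> Z) (j : 'I_3) : zmat :=
  ztab (fun x y => if all_qubits (fun k => (k != j) ==> (bitn k x == bitn k y))
                   then m (bitn j x) (bitn j y) else 0%Z).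

Definition zctrl4 (c : nat -> bool) (A : zmat) : zmat :=
  ztab (fun x y => if c y then (4 * zget A x y)%Z else if x == y then 4%Z else 0%Z).

Definition swapn (j k : 'I_3) (y : nat) : nat :=
  let b i := nat_of_bool (bitn (if i == j then k else if i == k then j else i) y) in
  (4 * b q0 + 2 * b q1 + b q2)%N.

Definition zswap4 (j k : 'I_3) : zmat :=
  ztab (fun x y => if x == swapn j k y then 4%Z else 0%Z).

Definition mX (a b : bool) : Z := if a == b then 0%Z else 1%Z.
Definition mZ (a b : bool) : Z := if a != b then 0%Z else if a then (-1)%Z else 1%Z.
Definition mH (a b : bool) : Z := if a && b then (-1)%Z else 1%Z.

Definition gate_zmat (s : sym) : zmat :=
  let cx j k := zctrl4 (bitn j) (one_qZ mX k) in
  let cz j k := zctrl4 (bitn j) (one_qZ mZ k) in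
  let ccx j k l := zctrl4 (fun y => bitn j y && bitn k y) (one_qZ mX l) in
  let kk j k := zscale 2 (zmul (one_qZ mH j) (one_qZ mH k)) in
  match s with
  | sX0 => zscale 4 (one_qZ mX q0) | sX1 => zscale 4 (one_qZ mX q1)
  | sX2 => zscale 4 (one_qZ mX q2)
  | sCX01 => cx q0 q1 | sCX02 => cx q0 q2 | sCX10 => cx q1 q0
  | sCX12 => cx q1 q2 | sCX20 => cx q2 q0 | sCX21 => cx q2 q1
  | sCCX01 => ccx q0 q1 q2 | sCCX02 => ccx q0 q2 q1 | sCCX12 => ccx q1 q2 q0
  | sZ0 => zscale 4 (one_qZ mZ q0) | sZ1 => zscale 4 (one_qZ mZ q1)
  | sZ2 => zscale 4 (one_qZ mZ q2)
  | sCZ01 => cz q0 q1 | sCZ02 => cz q0 q2 | sCZ12 => cz q1 q2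
  | sK01 => kk q0 q1 | sK12 => kk q1 q2
  | sS01 => zswap4 q0 q1 | sS02 => zswap4 q0 q2 | sS12 => zswap4 q1 q2
  end.

Section GateMatrices.
Variable R : realType.
Local Notation matZ := (@matZ R).

Lemma matZ_scale c A : matZ (zscale c A) = Z2R R c *: matZ A.
Proof.
by apply/matrixP=> i j; rewrite !mxE zget_map ?Z2R_mul // Z.mul_0_r.
Qed.

Lemma b2oE b : nat_of_ord (b2o b) = b.
Proof. by rewrite inordK //; case: b. Qed.

Lemma matZ_one_q m (M : 'M[R]_2) c j :
  (forall a b, Z2R R (m a b) = c * M (b2o a) (b2o b)) ->
  matZ (one_qZ m j) = c *: one_q M j.
Proof.
move=> mM; rewrite matZ_tab; apply/matrixP=> x y.
rewrite !mxE forall_qubitsE /all_qubits /bitn /bit.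
by case: ifP => _; [exact: mM | rewrite mulr0].
Qed.

Lemma matZ_ctrl4 (c : nat -> bool) A :
  matZ (zctrl4 c A) = 4 *: \matrix_(x, y) if c y then matZ A x y else (x == y)%:R.
Proof.
rewrite matZ_tab; apply/matrixP=> x y; rewrite !mxE.
case: ifP => _; first by rewrite Z2R_mul.
by rewrite val_eqE; case: eqP; rewrite ?mulr1 ?mulr0.
Qed.

Lemma swapnE j k (y : 'I_8) : nat_of_ord (swap_idx j k y) = swapn j k y.
Proof.
have qE (i : 'I_3) : @inord 2 i = i by rewrite inord_val.
rewrite /swap_idx /mkidx (qE q0) (qE q1) (qE q2) inordK //.
by do 3!case: (bit _ y).
Qed.

Lemma matZ_swap4 j k : matZ (zswap4 j k) = 4 *: sigma R j k.
Proof.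
rewrite matZ_tab; apply/matrixP=> x y; rewrite !mxE -val_eqE /= swapnE.
by case: eqP; rewrite ?mulr1 ?mulr0.
Qed.

Lemma matZ_X j : matZ (one_qZ mX j) = one_q (Xm R) j.
Proof.
rewrite (@matZ_one_q _ (Xm R) 1) ?scale1r // => a b.
by rewrite mul1r mxE -val_eqE /= !b2oE /mX; case: a; case: b.
Qed.

Lemma matZ_Z j : matZ (one_qZ mZ j) = one_q (Zm R) j.
Proof.
rewrite (@matZ_one_q _ (Zm R) 1) ?scale1r // => a b.
by rewrite mul1r mxE -!val_eqE /= !b2oE /mZ; case: a; case: b.
Qed.

Lemma sqrt2_neq0 : Num.sqrt (2 : R) != 0.
Proof. by rewrite sqrtr_eq0 -ltNge ltr0n. Qed.

Lemma matZ_H j : matZ (one_qZ mH j) = Num.sqrt 2 *: one_q (Hm R) j.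
Proof.
apply: matZ_one_q => a b; rewrite /Hm !mxE mulrA mulfV ?sqrt2_neq0 // mul1r.
by rewrite -!val_eqE /= !b2oE /mH; case: a; case: b.
Qed.

Lemma gate_zmatP s : zrep (gate_zmat s) (sem R s).
Proof.
rewrite /zrep; case: s; cbn [gate_zmat sem];
  rewrite ?matZ_scale ?matZ_ctrl4 ?matZ_swap4 ?matZ_mul ?matZ_X ?matZ_Z ?matZ_H //.
(* K_{j,k}: 2 (sqrt 2 H_j)(sqrt 2 H_k) = 4 H_j H_k *)
all: rewrite -scalemxAl -scalemxAr !scalerA -mulrA -expr2 sqr_sqrtr ?ler0n //.
all: by rewrite (_ : Z2R R 2 = 2) // -natrM.
Qed.

End GateMatrices.

Scheme Equality for sym.

Lemma sym_eqP : Equality.axiom sym_beq.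
Proof.
move=> x y; apply: (iffP idP).
  exact: internal_sym_dec_bl.
exact: internal_sym_dec_lb.
Qed.

HB.instance Definition _ := hasDecEq.Build sym sym_eqP.

Definition gate_table : sym -> zmat := Eval vm_compute in gate_zmat.

Lemma gate_tableE : gate_table =1 gate_zmat.
Proof. by case; vm_compute. Qed.

Definition word_zmat (w : seq sym) : option zmat := zprod4 (map gate_table w).

Definition same_matrix (w1 w2 : seq sym) : bool :=
  if word_zmat w1 is Some A then word_zmat w2 == Some A else false.

Definition annotate (T : seq (seq sym)) : seq (seq sym * zmat) :=
  pmap (fun w => omap (pair w) (word_zmat w)) T.

Fixpoint lookup (K V : eqType) (k : K) (kvs : seq (K * V)) : option V :=
  if kvs is kv :: kvs' then if kv.1 == k then Some kv.2 else lookup k kvs'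
  else None.

Definition zcol (c : nat) (A : zmat) : seq Z := map (fun r => nth 0%Z r c) A.

(* Level i holds coset representatives of the stabiliser of e_0, ..., e_i in
   the stabiliser of e_0, ..., e_(i-1), so they are told apart by their i-th
   column. *)
Fixpoint keyed_levels (c : nat) (Ts : seq (seq (seq sym))) :=
  if Ts is T :: Ts' then
    [seq (zcol c p.2, p) | p <- annotate T] :: keyed_levels c.+1 Ts'
  else [::].

(* Decomposes P into level representatives, assuming P fixes the basis
   vectors below c; the inverse of a representative is its transpose.
   The result is not trusted: [factors_ok] checks it. *)
Fixpoint sift (c : nat) KTs (P : zmat) : seq (seq sym * zmat) :=
  if KTs is KT :: KTs' then
    if lookup (zcol c P) KT is Some p then
      p :: sift c.+1 KTs' (zdiv4 (zmul (ztr p.2) P))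
    else [::]
  else [::].

Definition factors_ok c KTs (V U : zmat) : bool :=
  if zmul4 V U is Some P then
    if sift c KTs P is p :: ps then zprod4 (map snd (p :: ps)) == Some P else false
  else false.

Definition certify (c : nat) (T : seq (seq sym)) (Ts : seq (seq (seq sym)))
    (S : seq (seq sym)) : bool :=
  let KTs := keyed_levels c (T :: Ts) in
  all (fun u => if word_zmat u is Some U then
                  all (fun v => if word_zmat v is Some V
                                then factors_ok c KTs V U else false) S
                else false) T.

Fixpoint certify_chain (c : nat) (Ts : seq (seq (seq sym))) : bool :=
  if Ts is T :: Ts' then certify c T Ts' (flatten Ts) && certify_chain c.+1 Ts'
  else true.

Lemma mem_annotate T p : p \in annotate T -> p.1 \in T /\ word_zmat p.1 = Some p.2.
Proof.
rewrite mem_pmap => /mapP[w wT].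
by case eA: (word_zmat w) => [A|] //= [->].
Qed.

Lemma annotate_flatten Ts : annotate (flatten Ts) = flatten (map annotate Ts).
Proof. by elim: Ts => [|T Ts IH] //=; rewrite /annotate pmap_cat -IH. Qed.

Lemma lookup_mem (K V : eqType) (k : K) kvs (v : V) :
  lookup k kvs = Some v -> (k, v) \in kvs.
Proof.
elim: kvs => [|[k' v'] kvs IH] //=; case: eqP => [-> [->]|_ /IH].
  by rewrite mem_head.
by rewrite in_cons orbC => ->.
Qed.

Lemma lookup_keyed (K V : eqType) (key : V -> K) k (vs : seq V) v :
  lookup k [seq (key x, x) | x <- vs] = Some v -> v \in vs.
Proof. by move/lookup_mem/mapP=> [x xvs [_ ->]]. Qed.

Lemma sift_mem c Ts P :
  all (mem (flatten (map annotate Ts))) (sift c (keyed_levels c Ts) P).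
Proof.
elim: Ts c P => [//|T Ts IH] c P /=.
case eP: lookup => [p|] //=; rewrite mem_cat (lookup_keyed eP) /=.
by apply: sub_all (IH _ _) => x /= xTs; rewrite mem_cat xTs orbT.
Qed.

Lemma sift_head c T Ts P p ps : sift c (keyed_levels c (T :: Ts)) P = p :: ps ->
  p \in annotate T /\ all (mem (flatten (map annotate Ts))) ps.
Proof.
rewrite /=; case eP: lookup => [q|] // [<- <-].
by split; [exact: lookup_keyed eP | exact: sift_mem].
Qed.

Section Soundness.
Variable R : realType.
Local Notation eval := (eval (sem R)).

Lemma zprod4P (X : eqType) (g : X -> zmat) (h : X -> 'M[R]_8) xs P :
  {in xs, forall x, zrep (g x) (h x)} -> zprod4 (map g xs) = Some P ->
  zrep P (\prod_(x <- xs) h x).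
Proof.
elim: xs P => [|x xs IH] P xsR /=.
  by case=> <-; rewrite big_nil; exact: zrep_id4.
case eB: (zprod4 _) => [B|] //= xB; rewrite big_cons.
apply: zrep_mul xB; first by apply: xsR; rewrite mem_head.
by apply: IH eB => y yxs; apply: xsR; rewrite in_cons yxs orbT.
Qed.

Lemma word_zmatP w A : word_zmat w = Some A -> zrep A (eval w).
Proof. by apply: zprod4P => s _; rewrite gate_tableE; exact: gate_zmatP. Qed.

Lemma same_matrixP w1 w2 : same_matrix w1 w2 -> eval w1 = eval w2.
Proof.
rewrite /same_matrix; case e1: (word_zmat w1) => [A|] // /eqP e2.
exact: zrep_inj (word_zmatP e1) (word_zmatP e2).
Qed.

Lemma factors_okP c T Ts v u V U :
  word_zmat v = Some V -> word_zmat u = Some U ->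
  factors_ok c (keyed_levels c (T :: Ts)) V U ->
  exists2 u', u' \in T & exists2 ws, all (mem (flatten Ts)) ws &
    eval v * eval u = eval u' * \prod_(w <- ws) eval w.
Proof.
move=> vV uU; rewrite /factors_ok.
case eP: zmul4 => [P|] //; case eps: sift => [|p ps] // /eqP psP.
have [pT psTs] := sift_head eps.
have {}psTs q : q \in ps -> q.1 \in flatten Ts /\ word_zmat q.1 = Some q.2.
  by move=> qps; apply: mem_annotate; rewrite annotate_flatten; exact: (allP psTs).
have pqR q : q \in p :: ps -> zrep q.2 (eval q.1).
  rewrite in_cons => /predU1P[->|/psTs[_]]; last exact: word_zmatP.
  by case: (mem_annotate pT) => _; exact: word_zmatP.
exists p.1; first by case: (mem_annotate pT).
exists (map fst ps); first by apply/allP => _ /mapP[q /psTs[qTs _] ->].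
have := zprod4P pqR psP; rewrite big_cons -(big_map fst xpredT).
exact/zrep_inj/(zrep_mul (word_zmatP vV) (word_zmatP uU) eP).
Qed.

Lemma certifyP c T Ts S : certify c T Ts S -> absorbs (sem R) T Ts S.
Proof.
move=> /allP cert v u vS uT; move: (cert u uT).
case uU: (word_zmat u) => [U|] // /allP/(_ v vS).
case vV: (word_zmat v) => [V|] //; exact: factors_okP.
Qed.

Lemma certify_chainP c Ts : certify_chain c Ts -> absorbing_chain (sem R) Ts.
Proof.
by elim: Ts c => [//|T Ts IH] c /andP[/certifyP absT /IH chTs].
Qed.

End Soundness.

Definition gens : seq sym := [:: sCCX01; sK01; sS01; sS12; sZ0; sCZ01].

Definition gens_word (s : sym) : seq sym :=
  let conj p w := p ++ w ++ rev p in
  let s02 := [:: sS01; sS12; sS01] in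
  let k12 := conj s02 [:: sK01] in
  let x0 := [:: sK01; sZ0; sK01] in
  let cx01 := conj k12 [:: sCZ01] in
  match s with
  | sX0 => x0 | sX1 => conj [:: sS01] x0 | sX2 => conj s02 x0
  | sCX01 => cx01 | sCX02 => conj [:: sS12] cx01 | sCX10 => conj [:: sS01] cx01
  | sCX12 => conj [:: sS01; sS12] cx01 | sCX20 => conj [:: sS12; sS01] cx01
  | sCX21 => conj s02 cx01
  | sCCX01 => [:: sCCX01] | sCCX02 => conj [:: sS12] [:: sCCX01]
  | sCCX12 => conj s02 [:: sCCX01]
  | sZ0 => [:: sZ0] | sZ1 => conj [:: sS01] [:: sZ0] | sZ2 => conj s02 [:: sZ0]
  | sCZ01 => [:: sCZ01] | sCZ02 => conj [:: sS12] [:: sCZ01]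
  | sCZ12 => conj s02 [:: sCZ01]
  | sK01 => [:: sK01] | sK12 => k12
  | sS01 => [:: sS01] | sS02 => s02 | sS12 => [:: sS12]
  end.

Definition syms : seq sym :=
  [:: sX0; sX1; sX2; sCX01; sCX02; sCX10; sCX12; sCX20; sCX21; sCCX01; sCCX02;
      sCCX12; sZ0; sZ1; sZ2; sCZ01; sCZ02; sCZ12; sK01; sK12; sS01; sS02; sS12].

(* Transversals of the stabiliser chain of e_0, ..., e_6, found by computer
   search. *)
Definition level1 : seq (seq sym) := [:: [::];
 [:: sK01];
 [:: sK12];
 [:: sX0];
 [:: sX1];
 [:: sX2];
 [:: sCCX01; sK01];
 [:: sCCX12; sK12];
 [:: sCX02; sK01];
 [:: sCX10; sK12];
 [:: sCX12; sK01];
 [:: sCZ01; sK01];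
 [:: sCZ12; sK12];
 [:: sK01; sX0];
 [:: sK01; sX1];
 [:: sK01; sX2];
 [:: sK12; sK01];
 [:: sK12; sX0];
 [:: sK12; sX1];
 [:: sK12; sX2];
 [:: sX1; sX0];
 [:: sX2; sX0];
 [:: sX2; sX1];
 [:: sZ0; sX0];
 [:: sZ1; sX1];
 [:: sZ2; sX2];
 [:: sCCX01; sCX02; sK01];
 [:: sCCX01; sCX12; sK01];
 [:: sCCX01; sCZ01; sK01];
 [:: sCCX01; sK01; sX0];
 [:: sCCX01; sK01; sX1];
 [:: sCCX01; sK01; sX2];
 [:: sCCX02; sCX10; sK12];
 [:: sCCX02; sCX12; sK01];
 [:: sCCX02; sK12; sK01];
 [:: sCCX12; sCX02; sK01];
 [:: sCCX12; sCX10; sK12];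
 [:: sCCX12; sCZ12; sK12];
 [:: sCCX12; sK12; sX0];
 [:: sCCX12; sK12; sX1];
 [:: sCCX12; sK12; sX2];
 [:: sCX01; sCCX12; sK12];
 [:: sCX01; sCX12; sK01];
 [:: sCX02; sCCX12; sK12];
 [:: sCX02; sK01; sX1];
 [:: sCX10; sK12; sX0];
 [:: sCX10; sK12; sX1];
 [:: sCX10; sK12; sX2];
 [:: sCX12; sK01; sX1];
 [:: sCX12; sK01; sX2];
 [:: sCX20; sCCX01; sK01];
 [:: sCX20; sK12; sX0];
 [:: sCX20; sK12; sX2];
 [:: sCX21; sCCX01; sK01];
 [:: sCZ01; sCX02; sK01];
 [:: sCZ01; sCX12; sK01];
 [:: sCZ01; sK01; sX0];
 [:: sCZ01; sK01; sX1];
 [:: sCZ01; sK01; sX2];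
 [:: sCZ02; sCX10; sK12];
 [:: sCZ12; sK12; sX0];
 [:: sCZ12; sK12; sX1];
 [:: sCZ12; sK12; sX2];
 [:: sK01; sCCX01; sK01];
 [:: sK01; sCX02; sK01];
 [:: sK01; sK12; sX0];
 [:: sK01; sX1; sX0];
 [:: sK01; sX2; sX0];
 [:: sK01; sX2; sX1];
 [:: sK01; sZ0; sX0];
 [:: sK01; sZ1; sX1];
 [:: sK01; sZ2; sX2];
 [:: sK12; sK01; sX2];
 [:: sK12; sX1; sX0];
 [:: sK12; sX2; sX0];
 [:: sK12; sX2; sX1];
 [:: sK12; sZ0; sX0];
 [:: sK12; sZ1; sX1];
 [:: sK12; sZ2; sX2];
 [:: sS01; sK12; sX0];
 [:: sX0; sZ1; sX1];
 [:: sX0; sZ2; sX2];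
 [:: sX1; sZ2; sX2];
 [:: sX2; sX1; sX0];
 [:: sX2; sZ2; sX2];
 [:: sZ0; sCX12; sK01];
 [:: sCCX01; sCX01; sCX12; sK01];
 [:: sCCX01; sCX02; sK01; sX1];
 [:: sCCX01; sCX12; sK01; sX1];
 [:: sCCX01; sCX12; sK01; sX2];
 [:: sCCX01; sCX20; sK12; sX0];
 [:: sCCX01; sCX20; sK12; sX2];
 [:: sCCX01; sCZ01; sCX02; sK01];
 [:: sCCX01; sCZ01; sCX12; sK01];
 [:: sCCX01; sCZ01; sK01; sX0];
 [:: sCCX01; sCZ01; sK01; sX1];
 [:: sCCX01; sCZ01; sK01; sX2];
 [:: sCCX01; sK01; sX1; sX0];
 [:: sCCX01; sK01; sX2; sX0];
 [:: sCCX01; sK01; sX2; sX1];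
 [:: sCCX01; sK01; sZ0; sX0];
 [:: sCCX01; sK01; sZ1; sX1];
 [:: sCCX01; sK01; sZ2; sX2];
 [:: sCCX01; sZ0; sCX12; sK01];
 [:: sCCX02; sCX01; sCX12; sK01];
 [:: sCCX02; sCX10; sK12; sX0];
 [:: sCCX02; sCX10; sK12; sX1];
 [:: sCCX02; sCX10; sK12; sX2];
 [:: sCCX02; sCX12; sK01; sX1];
 [:: sCCX02; sCX12; sK01; sX2];
 [:: sCCX02; sCZ01; sCX12; sK01];
 [:: sCCX02; sCZ02; sCX10; sK12];
 [:: sCCX02; sK01; sCX02; sK01];
 [:: sCCX02; sK01; sK12; sX0];
 [:: sCCX02; sK12; sK01; sX2];
 [:: sCCX02; sS01; sK12; sX0];
 [:: sCCX02; sZ0; sCX12; sK01];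
 [:: sCCX12; sCX01; sCX12; sK01];
 [:: sCCX12; sCX02; sK01; sX1];
 [:: sCCX12; sCX10; sK12; sX0];
 [:: sCCX12; sCX10; sK12; sX1];
 [:: sCCX12; sCX10; sK12; sX2];
 [:: sCCX12; sCX20; sK12; sX0];
 [:: sCCX12; sCX20; sK12; sX2];
 [:: sCCX12; sCZ01; sCX02; sK01];
 [:: sCCX12; sCZ02; sCX10; sK12];
 [:: sCCX12; sCZ12; sK12; sX0];
 [:: sCCX12; sCZ12; sK12; sX1];
 [:: sCCX12; sCZ12; sK12; sX2];
 [:: sCCX12; sK12; sX1; sX0];
 [:: sCCX12; sK12; sX2; sX0];
 [:: sCCX12; sK12; sX2; sX1];
 [:: sCCX12; sK12; sZ0; sX0];
 [:: sCCX12; sK12; sZ1; sX1];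
 [:: sCCX12; sK12; sZ2; sX2];
 [:: sCX01; sCCX01; sK01; sX1];
 [:: sCX01; sCCX12; sCX02; sK01];
 [:: sCX01; sCCX12; sCZ12; sK12];
 [:: sCX01; sCCX12; sK12; sX0];
 [:: sCX01; sCCX12; sK12; sX1];
 [:: sCX01; sCCX12; sK12; sX2];
 [:: sCX01; sCX20; sCCX01; sK01];
 [:: sCX01; sZ0; sCX12; sK01];
 [:: sCX02; sCCX12; sCX10; sK12];
 [:: sCX02; sCCX12; sCZ12; sK12];
 [:: sCX02; sCCX12; sK12; sX0];
 [:: sCX02; sCCX12; sK12; sX1];
 [:: sCX02; sCCX12; sK12; sX2];
 [:: sCX02; sCZ01; sK01; sX2];
 [:: sCX02; sK01; sX2; sX0];
 [:: sCX02; sK01; sZ0; sX0];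
 [:: sCX02; sK01; sZ2; sX2];
 [:: sCX10; sCCX01; sK01; sX0];
 [:: sCX10; sCCX02; sCX12; sK01];
 [:: sCX10; sCX02; sK01; sX1];
 [:: sCX10; sCX21; sCCX01; sK01];
 [:: sCX10; sCZ12; sK12; sX0];
 [:: sCX10; sCZ12; sK12; sX1];
 [:: sCX10; sK01; sZ0; sX0];
 [:: sCX10; sK12; sX1; sX0];
 [:: sCX10; sK12; sX2; sX0];
 [:: sCX10; sK12; sX2; sX1];
 [:: sCX10; sK12; sZ0; sX0];
 [:: sCX10; sK12; sZ1; sX1];
 [:: sCX10; sK12; sZ2; sX2];
 [:: sCX12; sCCX02; sCX10; sK12];
 [:: sCX12; sCCX12; sK12; sX2];
 [:: sCX12; sCX01; sCCX12; sK12];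
 [:: sCX12; sCZ01; sK01; sX1];
 [:: sCX12; sCZ01; sK01; sX2];
 [:: sCX12; sK01; sX1; sX0];
 [:: sCX12; sK01; sX2; sX0];
 [:: sCX12; sK01; sX2; sX1];
 [:: sCX12; sK01; sZ0; sX0];
 [:: sCX12; sK01; sZ1; sX1];
 [:: sCX12; sK01; sZ2; sX2];
 [:: sCX20; sCCX01; sCX12; sK01];
 [:: sCX20; sCCX01; sCZ01; sK01];
 [:: sCX20; sCCX01; sK01; sX0];
 [:: sCX20; sCCX01; sK01; sX1];
 [:: sCX20; sCCX01; sK01; sX2];
 [:: sCX20; sCX10; sK12; sX0];
 [:: sCX20; sCX10; sK12; sX2];
 [:: sCX20; sCX21; sCCX01; sK01];
 [:: sCX20; sCZ12; sK12; sX0];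
 [:: sCX20; sCZ12; sK12; sX2];
 [:: sCX20; sK12; sX1; sX0];
 [:: sCX20; sK12; sX2; sX0];
 [:: sCX20; sK12; sX2; sX1];
 [:: sCX20; sK12; sZ1; sX1];
 [:: sCX21; sCCX01; sCX02; sK01];
 [:: sCX21; sCCX01; sCX12; sK01];
 [:: sCX21; sCCX01; sCZ01; sK01];
 [:: sCX21; sCCX01; sK01; sX0];
 [:: sCX21; sCCX01; sK01; sX1];
 [:: sCX21; sCCX01; sK01; sX2];
 [:: sCX21; sCCX12; sK12; sX1];
 [:: sCX21; sK12; sZ1; sX1];
 [:: sCZ01; sCCX12; sK12; sX0];
 [:: sCZ01; sCX01; sCX12; sK01];
 [:: sCZ01; sCX02; sK01; sX1];
 [:: sCZ01; sK01; sX1; sX0];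
 [:: sCZ01; sK01; sX2; sX0];
 [:: sCZ01; sK01; sX2; sX1];
 [:: sCZ01; sK01; sZ0; sX0];
 [:: sCZ01; sK01; sZ1; sX1];
 [:: sCZ01; sK01; sZ2; sX2];
 [:: sCZ01; sZ0; sCX12; sK01];
 [:: sCZ02; sCCX01; sK01; sX2];
 [:: sCZ02; sCCX12; sK12; sX0];
 [:: sCZ02; sCX01; sCX12; sK01];
 [:: sCZ02; sCX10; sK12; sX0];
 [:: sCZ02; sCX10; sK12; sX2];
 [:: sCZ02; sCX12; sK01; sX2];
 [:: sCZ12; sCCX01; sK01; sX2];
 [:: sCZ12; sCX01; sCX12; sK01];
 [:: sCZ12; sK12; sX1; sX0];
 [:: sCZ12; sK12; sX2; sX0];
 [:: sCZ12; sK12; sX2; sX1];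
 [:: sCZ12; sK12; sZ0; sX0];
 [:: sCZ12; sK12; sZ1; sX1];
 [:: sCZ12; sK12; sZ2; sX2];
 [:: sK01; sCCX01; sCX02; sK01];
 [:: sK01; sCCX01; sCX12; sK01];
 [:: sK01; sCCX01; sCZ01; sK01];
 [:: sK01; sCCX01; sK01; sX1];
 [:: sK01; sCCX01; sK01; sX2];
 [:: sK01; sCX20; sCCX01; sK01];
 [:: sK01; sCX20; sK12; sX0];
 [:: sK01; sCX21; sCCX01; sK01];
 [:: sK01; sK12; sX1; sX0];
 [:: sK01; sK12; sX2; sX0];
 [:: sK01; sK12; sZ1; sX1];
 [:: sK01; sX2; sX1; sX0];
 [:: sK01; sX2; sZ2; sX2];
 [:: sK12; sCCX12; sK12; sX0];
 [:: sK12; sCX01; sCCX12; sK12];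
 [:: sK12; sCX20; sCCX01; sK01];
 [:: sK12; sCX20; sK12; sX0];
 [:: sK12; sX2; sX1; sX0];
 [:: sK12; sX2; sZ2; sX2];
 [:: sS01; sCZ12; sK12; sX0];
 [:: sS01; sK12; sX2; sX0];
 [:: sS01; sK12; sZ1; sX1];
 [:: sS12; sCX20; sCCX01; sK01];
 [:: sS12; sK01; sZ1; sX1];
 [:: sX0; sCCX01; sK01; sX0];
 [:: sX0; sCX01; sCCX12; sK12];
 [:: sX0; sCX02; sCCX12; sK12];
 [:: sX0; sK12; sZ1; sX1];
 [:: sX0; sK12; sZ2; sX2];
 [:: sX0; sX1; sZ2; sX2];
 [:: sX1; sCCX01; sCX12; sK01];
 [:: sX1; sCCX01; sK01; sX1];
 [:: sX1; sCCX12; sK12; sX1];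
 [:: sX1; sCZ01; sK01; sX1];
 [:: sX2; sCCX02; sCX12; sK01];
 [:: sX2; sCCX12; sCX02; sK01];
 [:: sX2; sCCX12; sK12; sX2];
 [:: sX2; sCX20; sCCX01; sK01];
 [:: sX2; sCX21; sCCX01; sK01];
 [:: sX2; sCZ12; sK12; sX2];
 [:: sX2; sK01; sZ0; sX0];
 [:: sX2; sK01; sZ1; sX1];
 [:: sZ0; sCCX12; sCX02; sK01];
 [:: sZ0; sCCX12; sCX10; sK12];
 [:: sZ0; sCCX12; sK12; sX0];
 [:: sZ0; sCX10; sK12; sX0];
 [:: sZ0; sCX20; sCCX01; sK01];
 [:: sZ1; sCCX02; sCX10; sK12];
 [:: sZ1; sCCX02; sCX12; sK01];
 [:: sZ1; sCX01; sCCX12; sK12];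
 [:: sZ1; sCX21; sCCX01; sK01];
 [:: sZ2; sCCX01; sCX02; sK01];
 [:: sZ2; sCCX01; sCX12; sK01];
 [:: sZ2; sCCX01; sK01; sX2];
 [:: sZ2; sCX02; sCCX12; sK12];
 [:: sZ2; sCX12; sK01; sX2];
 [:: sCCX01; sCX01; sZ0; sCX12; sK01];
 [:: sCCX01; sCX02; sCZ01; sK01; sX2];
 [:: sCCX01; sCX02; sK01; sX2; sX0];
 [:: sCCX01; sCX02; sK01; sZ0; sX0];
 [:: sCCX01; sCX02; sK01; sZ2; sX2];
 [:: sCCX01; sCX10; sCX02; sK01; sX1];
 [:: sCCX01; sCX10; sK01; sZ0; sX0];
 [:: sCCX01; sCX12; sCZ01; sK01; sX2];
 [:: sCCX01; sCX12; sK01; sX2; sX0];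
 [:: sCCX01; sCX12; sK01; sX2; sX1];
 [:: sCCX01; sCX12; sK01; sZ1; sX1];
 [:: sCCX01; sCX12; sK01; sZ2; sX2];
 [:: sCCX01; sCX20; sCX10; sK12; sX2];
 [:: sCCX01; sCX20; sCZ12; sK12; sX0];
 [:: sCCX01; sCX20; sK12; sX1; sX0];
 [:: sCCX01; sCX20; sK12; sX2; sX0];
 [:: sCCX01; sCZ01; sCX01; sCX12; sK01];
 [:: sCCX01; sCZ01; sCX02; sK01; sX1];
 [:: sCCX01; sCZ01; sK01; sX1; sX0];
 [:: sCCX01; sCZ01; sK01; sZ0; sX0];
 [:: sCCX01; sCZ01; sK01; sZ1; sX1];
 [:: sCCX01; sCZ01; sZ0; sCX12; sK01];
 [:: sCCX01; sCZ02; sCX01; sCX12; sK01];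
 [:: sCCX01; sCZ02; sCX12; sK01; sX2];
 [:: sCCX01; sCZ12; sCX01; sCX12; sK01];
 [:: sCCX01; sK01; sX2; sX1; sX0];
 [:: sCCX01; sK01; sX2; sZ2; sX2];
 [:: sCCX01; sX1; sCZ01; sK01; sX1];
 [:: sCCX01; sX2; sK01; sZ0; sX0];
 [:: sCCX01; sX2; sK01; sZ1; sX1];
 [:: sCCX01; sZ2; sCX12; sK01; sX2];
 [:: sCCX02; sCX01; sZ0; sCX12; sK01];
 [:: sCCX02; sCX10; sCX02; sK01; sX1];
 [:: sCCX02; sCX10; sCZ12; sK12; sX0];
 [:: sCCX02; sCX10; sK12; sX1; sX0];
 [:: sCCX02; sCX10; sK12; sX2; sX0];
 [:: sCCX02; sCX10; sK12; sX2; sX1];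
 [:: sCCX02; sCX10; sK12; sZ0; sX0];
 [:: sCCX02; sCX10; sK12; sZ1; sX1];
 [:: sCCX02; sCX10; sK12; sZ2; sX2];
 [:: sCCX02; sCX12; sCZ01; sK01; sX2];
 [:: sCCX02; sCX12; sK01; sX1; sX0];
 [:: sCCX02; sCX12; sK01; sX2; sX0];
 [:: sCCX02; sCX12; sK01; sX2; sX1];
 [:: sCCX02; sCX12; sK01; sZ0; sX0];
 [:: sCCX02; sCX12; sK01; sZ1; sX1];
 [:: sCCX02; sCX12; sK01; sZ2; sX2];
 [:: sCCX02; sCX20; sCX10; sK12; sX2];
 [:: sCCX02; sCZ01; sCX01; sCX12; sK01];
 [:: sCCX02; sCZ01; sZ0; sCX12; sK01];
 [:: sCCX02; sCZ02; sCX01; sCX12; sK01];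
 [:: sCCX02; sCZ02; sCX10; sK12; sX0];
 [:: sCCX02; sCZ02; sCX10; sK12; sX2];
 [:: sCCX02; sCZ02; sCX12; sK01; sX2];
 [:: sCCX02; sCZ12; sCX01; sCX12; sK01];
 [:: sCCX02; sK01; sCX20; sK12; sX0];
 [:: sCCX02; sK01; sK12; sX1; sX0];
 [:: sCCX02; sK01; sK12; sX2; sX0];
 [:: sCCX02; sK01; sK12; sZ1; sX1];
 [:: sCCX02; sK12; sCX20; sK12; sX0];
 [:: sCCX02; sS01; sCZ12; sK12; sX0];
 [:: sCCX02; sS01; sK12; sX2; sX0];
 [:: sCCX02; sS01; sK12; sZ1; sX1];
 [:: sCCX02; sS12; sK01; sZ1; sX1];
 [:: sCCX02; sZ0; sCX10; sK12; sX0];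
 [:: sCCX02; sZ2; sCX12; sK01; sX2];
 [:: sCCX12; sCX01; sZ0; sCX12; sK01];
 [:: sCCX12; sCX02; sCZ01; sK01; sX2];
 [:: sCCX12; sCX02; sK01; sX2; sX0];
 [:: sCCX12; sCX02; sK01; sZ0; sX0];
 [:: sCCX12; sCX02; sK01; sZ2; sX2];
 [:: sCCX12; sCX10; sCX02; sK01; sX1];
 [:: sCCX12; sCX10; sCZ12; sK12; sX0];
 [:: sCCX12; sCX10; sK12; sX1; sX0];
 [:: sCCX12; sCX10; sK12; sX2; sX0];
 [:: sCCX12; sCX10; sK12; sZ0; sX0];
 [:: sCCX12; sCX10; sK12; sZ1; sX1];
 [:: sCCX12; sCX20; sCX10; sK12; sX2];
 [:: sCCX12; sCX20; sCZ12; sK12; sX0];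
 [:: sCCX12; sCX20; sK12; sX1; sX0];
 [:: sCCX12; sCX20; sK12; sX2; sX0];
 [:: sCCX12; sCX21; sK12; sZ1; sX1];
 [:: sCCX12; sCZ01; sCX01; sCX12; sK01];
 [:: sCCX12; sCZ01; sCX02; sK01; sX1];
 [:: sCCX12; sCZ02; sCX01; sCX12; sK01];
 [:: sCCX12; sCZ02; sCX10; sK12; sX0];
 [:: sCCX12; sCZ02; sCX10; sK12; sX2];
 [:: sCCX12; sCZ12; sCX01; sCX12; sK01];
 [:: sCCX12; sCZ12; sK12; sX2; sX1];
 [:: sCCX12; sCZ12; sK12; sZ1; sX1];
 [:: sCCX12; sCZ12; sK12; sZ2; sX2];
 [:: sCCX12; sK12; sX2; sX1; sX0];
 [:: sCCX12; sK12; sX2; sZ2; sX2];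
 [:: sCCX12; sX0; sK12; sZ1; sX1];
 [:: sCCX12; sX0; sK12; sZ2; sX2];
 [:: sCCX12; sX2; sCZ12; sK12; sX2];
 [:: sCCX12; sZ0; sCX10; sK12; sX0];
 [:: sCX01; sCCX01; sK01; sX2; sX1];
 [:: sCX01; sCCX01; sK01; sZ1; sX1];
 [:: sCX01; sCCX12; sCX02; sK01; sX1];
 [:: sCX01; sCCX12; sCX10; sK12; sX2];
 [:: sCX01; sCCX12; sCZ01; sCX02; sK01];
 [:: sCX01; sCCX12; sCZ12; sK12; sX0];
 [:: sCX01; sCCX12; sK12; sX1; sX0];
 [:: sCX01; sCCX12; sK12; sX2; sX0];
 [:: sCX01; sCCX12; sK12; sX2; sX1];
 [:: sCX01; sCCX12; sK12; sZ0; sX0];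
 [:: sCX01; sCCX12; sK12; sZ1; sX1];
 [:: sCX01; sCCX12; sK12; sZ2; sX2];
 [:: sCX01; sCX12; sCCX12; sK12; sX2];
 [:: sCX01; sCX12; sK01; sX2; sX1];
 [:: sCX01; sCX12; sK01; sZ2; sX2];
 [:: sCX01; sCX20; sCCX01; sK01; sX1];
 [:: sCX01; sCX21; sCCX12; sK12; sX1];
 [:: sCX01; sCZ01; sCCX12; sK12; sX0];
 [:: sCX01; sCZ02; sCCX12; sK12; sX0];
 [:: sCX01; sK01; sCCX01; sK01; sX1];
 [:: sCX01; sX1; sCCX12; sK12; sX1];
 [:: sCX01; sX2; sCCX12; sK12; sX2];
 [:: sCX01; sZ0; sCCX12; sCX02; sK01];
 [:: sCX01; sZ0; sCCX12; sK12; sX0];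
 [:: sCX01; sZ0; sCX20; sCCX01; sK01];
 [:: sCX01; sZ1; sCX21; sCCX01; sK01];
 [:: sCX01; sZ2; sCX02; sCCX12; sK12];
 [:: sCX02; sCCX12; sCX10; sK12; sX2];
 [:: sCX02; sCCX12; sCZ02; sCX10; sK12];
 [:: sCX02; sCCX12; sCZ12; sK12; sX0];
 [:: sCX02; sCCX12; sK12; sX1; sX0];
 [:: sCX02; sCCX12; sK12; sX2; sX0];
 [:: sCX02; sCCX12; sK12; sX2; sX1];
 [:: sCX02; sCCX12; sK12; sZ0; sX0];
 [:: sCX02; sCCX12; sK12; sZ1; sX1];
 [:: sCX02; sCCX12; sK12; sZ2; sX2];
 [:: sCX02; sCX01; sCCX12; sK12; sX0];
 [:: sCX02; sCX01; sCCX12; sK12; sX1];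
 [:: sCX02; sCX01; sCCX12; sK12; sX2];
 [:: sCX02; sCX10; sK12; sX2; sX0];
 [:: sCX02; sCX12; sCCX12; sK12; sX2];
 [:: sCX02; sCZ01; sCCX12; sK12; sX0];
 [:: sCX02; sCZ02; sCCX01; sK01; sX2];
 [:: sCX02; sCZ02; sCCX12; sK12; sX0];
 [:: sCX02; sCZ02; sCX12; sK01; sX2];
 [:: sCX02; sK01; sCX21; sCCX01; sK01];
 [:: sCX02; sK01; sX2; sX1; sX0];
 [:: sCX02; sX0; sCCX01; sK01; sX0];
 [:: sCX02; sX1; sCZ01; sK01; sX1];
 [:: sCX02; sX2; sCCX12; sK12; sX2];
 [:: sCX02; sZ0; sCCX12; sCX10; sK12];
 [:: sCX02; sZ0; sCCX12; sK12; sX0];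
 [:: sCX02; sZ2; sCCX01; sK01; sX2];
 [:: sCX02; sZ2; sCX12; sK01; sX2];
 [:: sCX10; sCCX01; sK01; sX2; sX0];
 [:: sCX10; sCCX01; sK01; sZ0; sX0];
 [:: sCX10; sCCX02; sCX12; sK01; sX1];
 [:: sCX10; sCCX02; sCZ01; sCX12; sK01];
 [:: sCX10; sCCX02; sZ0; sCX12; sK01];
 [:: sCX10; sCX02; sK01; sZ0; sX0];
 [:: sCX10; sCX12; sK01; sZ0; sX0];
 [:: sCX10; sCX20; sK12; sX2; sX0];
 [:: sCX10; sCX21; sCCX01; sK01; sX0];
 [:: sCX10; sCX21; sCCX01; sK01; sX1];
 [:: sCX10; sCX21; sCCX01; sK01; sX2];
 [:: sCX10; sCZ12; sK12; sX2; sX1];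
 [:: sCX10; sCZ12; sK12; sZ2; sX2];
 [:: sCX10; sK01; sCCX01; sK01; sX1];
 [:: sCX10; sK12; sX2; sZ2; sX2];
 [:: sCX10; sX1; sCCX12; sK12; sX1];
 [:: sCX10; sX2; sCZ12; sK12; sX2];
 [:: sCX10; sZ0; sCCX12; sK12; sX0];
 [:: sCX10; sZ0; sCX20; sCCX01; sK01];
 [:: sCX10; sZ1; sCCX02; sCX12; sK01];
 [:: sCX10; sZ1; sCX21; sCCX01; sK01];
 [:: sCX12; sCCX02; sCX10; sK12; sX1];
 [:: sCX12; sCCX02; sCX10; sK12; sX2];
 [:: sCX12; sCCX02; sCZ02; sCX10; sK12];
 [:: sCX12; sCCX12; sK12; sX2; sX0];
 [:: sCX12; sCCX12; sK12; sZ2; sX2];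
 [:: sCX12; sCX01; sCCX12; sK12; sX0];
 [:: sCX12; sCX01; sCCX12; sK12; sX1];
 [:: sCX12; sCX01; sCCX12; sK12; sX2];
 [:: sCX12; sCX20; sCZ12; sK12; sX0];
 [:: sCX12; sCX20; sK12; sX2; sX0];
 [:: sCX12; sCZ01; sK01; sX1; sX0];
 [:: sCX12; sCZ01; sK01; sZ0; sX0];
 [:: sCX12; sCZ12; sCCX01; sK01; sX2];
 [:: sCX12; sK01; sCCX01; sK01; sX1];
 [:: sCX12; sK01; sX2; sZ2; sX2];
 [:: sCX12; sX1; sCCX01; sK01; sX1];
 [:: sCX12; sX1; sCZ01; sK01; sX1];
 [:: sCX12; sZ1; sCCX02; sCX10; sK12];
 [:: sCX12; sZ1; sCX01; sCCX12; sK12];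
 [:: sCX12; sZ2; sCCX01; sK01; sX2];
 [:: sCX12; sZ2; sCX02; sCCX12; sK12];
 [:: sCX20; sCCX01; sCZ01; sCX12; sK01];
 [:: sCX20; sCCX01; sCZ01; sK01; sX2];
 [:: sCX20; sCCX01; sK01; sX1; sX0];
 [:: sCX20; sCCX01; sK01; sX2; sX0];
 [:: sCX20; sCCX01; sK01; sX2; sX1];
 [:: sCX20; sCCX01; sK01; sZ0; sX0];
 [:: sCX20; sCCX01; sK01; sZ1; sX1];
 [:: sCX20; sCCX01; sK01; sZ2; sX2];
 [:: sCX20; sCCX01; sZ0; sCX12; sK01];
 [:: sCX20; sCX10; sCCX01; sK01; sX0];
 [:: sCX20; sCX10; sCZ12; sK12; sX0];
 [:: sCX20; sCX10; sK12; sX1; sX0];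
 [:: sCX20; sCX10; sK12; sZ1; sX1];
 [:: sCX20; sCZ02; sCCX01; sK01; sX2];
 [:: sCX20; sCZ12; sCCX01; sK01; sX2];
 [:: sCX20; sCZ12; sK12; sX2; sX1];
 [:: sCX20; sCZ12; sK12; sZ1; sX1];
 [:: sCX20; sK01; sCCX01; sK01; sX1];
 [:: sCX20; sK12; sCX01; sCCX12; sK12];
 [:: sCX20; sK12; sX2; sZ2; sX2];
 [:: sCX20; sS01; sK12; sZ1; sX1];
 [:: sCX20; sX0; sCCX01; sK01; sX0];
 [:: sCX20; sX2; sCCX12; sK12; sX2];
 [:: sCX20; sZ0; sCCX12; sK12; sX0];
 [:: sCX20; sZ1; sCX21; sCCX01; sK01];
 [:: sCX20; sZ2; sCCX01; sCX12; sK01];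
 [:: sCX20; sZ2; sCCX01; sK01; sX2];
 [:: sCX21; sCCX01; sCX02; sK01; sX1];
 [:: sCX21; sCCX01; sCZ01; sCX02; sK01];
 [:: sCX21; sCCX01; sCZ01; sK01; sX2];
 [:: sCX21; sCCX01; sK01; sX1; sX0];
 [:: sCX21; sCCX01; sK01; sX2; sX0];
 [:: sCX21; sCCX01; sK01; sX2; sX1];
 [:: sCX21; sCCX01; sK01; sZ0; sX0];
 [:: sCX21; sCCX01; sK01; sZ1; sX1];
 [:: sCX21; sCCX01; sK01; sZ2; sX2];
 [:: sCX21; sCCX01; sZ0; sCX12; sK01];
 [:: sCX21; sCCX12; sK12; sX1; sX0];
 [:: sCX21; sCCX12; sK12; sZ1; sX1];
 [:: sCX21; sCX01; sCCX01; sK01; sX1];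
 [:: sCX21; sCX02; sCCX12; sK12; sX0];
 [:: sCX21; sCX02; sCCX12; sK12; sX1];
 [:: sCX21; sCX02; sCCX12; sK12; sX2];
 [:: sCX21; sCX10; sCCX01; sK01; sX0];
 [:: sCX21; sCX10; sCZ12; sK12; sX0];
 [:: sCX21; sCX10; sK12; sZ1; sX1];
 [:: sCX21; sCX20; sCCX01; sK01; sX1];
 [:: sCX21; sCZ02; sCCX01; sK01; sX2];
 [:: sCX21; sCZ12; sCCX01; sK01; sX2];
 [:: sCX21; sX0; sCCX01; sK01; sX0];
 [:: sCX21; sX1; sCCX01; sK01; sX1];
 [:: sCX21; sZ0; sCX10; sK12; sX0];
 [:: sCX21; sZ0; sCX20; sCCX01; sK01];
 [:: sCX21; sZ1; sCX01; sCCX12; sK12];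
 [:: sCX21; sZ2; sCCX01; sCX02; sK01];
 [:: sCX21; sZ2; sCCX01; sK01; sX2];
 [:: sCX21; sZ2; sCX02; sCCX12; sK12];
 [:: sCZ01; sCCX12; sK12; sX2; sX0];
 [:: sCZ01; sCCX12; sK12; sZ0; sX0];
 [:: sCZ01; sCX01; sCCX01; sK01; sX1];
 [:: sCZ01; sCX01; sCCX12; sK12; sX0];
 [:: sCZ01; sCX02; sK01; sX2; sX0];
 [:: sCZ01; sCX02; sK01; sZ0; sX0];
 [:: sCZ01; sCX02; sK01; sZ2; sX2];
 [:: sCZ01; sCX10; sCCX01; sK01; sX0];
 [:: sCZ01; sCX12; sK01; sX2; sX1];
 [:: sCZ01; sCX12; sK01; sZ1; sX1];
 [:: sCZ01; sCX12; sK01; sZ2; sX2];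
 [:: sCZ01; sCX20; sCX10; sK12; sX2];
 [:: sCZ01; sCX20; sK12; sX2; sX0];
 [:: sCZ01; sK01; sCCX01; sK01; sX1];
 [:: sCZ01; sK01; sCCX01; sK01; sX2];
 [:: sCZ01; sK01; sX2; sX1; sX0];
 [:: sCZ01; sK01; sX2; sZ2; sX2];
 [:: sCZ01; sX0; sCCX01; sK01; sX0];
 [:: sCZ01; sX0; sCX02; sCCX12; sK12];
 [:: sCZ01; sX1; sCCX01; sCX12; sK01];
 [:: sCZ01; sX1; sCCX01; sK01; sX1];
 [:: sCZ01; sZ2; sCX12; sK01; sX2];
 [:: sCZ02; sCCX01; sK01; sX2; sX1];
 [:: sCZ02; sCCX01; sK01; sZ2; sX2];
 [:: sCZ02; sCCX12; sK12; sZ0; sX0];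
 [:: sCZ02; sCX02; sCCX12; sK12; sX0];
 [:: sCZ02; sCX10; sK12; sX1; sX0];
 [:: sCZ02; sCX10; sK12; sZ0; sX0];
 [:: sCZ02; sCX10; sK12; sZ1; sX1];
 [:: sCZ02; sCX12; sK01; sX2; sX1];
 [:: sCZ02; sCX12; sK01; sZ2; sX2];
 [:: sCZ02; sCX20; sCCX01; sK01; sX2];
 [:: sCZ02; sK01; sCCX01; sK01; sX1];
 [:: sCZ02; sS01; sK12; sZ1; sX1];
 [:: sCZ02; sX0; sCX01; sCCX12; sK12];
 [:: sCZ02; sX2; sCCX02; sCX12; sK01];
 [:: sCZ02; sX2; sCX21; sCCX01; sK01];
 [:: sCZ02; sZ0; sCX10; sK12; sX0];
 [:: sCZ02; sZ2; sCX12; sK01; sX2];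
 [:: sCZ12; sCCX01; sK01; sZ2; sX2];
 [:: sCZ12; sCX02; sK01; sZ2; sX2];
 [:: sCZ12; sCX10; sK12; sX1; sX0];
 [:: sCZ12; sCX10; sK12; sZ0; sX0];
 [:: sCZ12; sCX20; sK12; sX2; sX0];
 [:: sCZ12; sCX21; sCCX01; sK01; sX2];
 [:: sCZ12; sK01; sCCX01; sK01; sX1];
 [:: sCZ12; sK12; sCCX12; sK12; sX0];
 [:: sCZ12; sK12; sCX01; sCCX12; sK12];
 [:: sCZ12; sK12; sX2; sX1; sX0];
 [:: sCZ12; sK12; sX2; sZ2; sX2];
 [:: sCZ12; sX1; sCCX12; sK12; sX1];
 [:: sCZ12; sX2; sCCX12; sCX02; sK01];
 [:: sCZ12; sX2; sCCX12; sK12; sX2];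
 [:: sCZ12; sX2; sCX20; sCCX01; sK01];
 [:: sK01; sCCX01; sCX01; sCX12; sK01];
 [:: sK01; sCCX01; sCX12; sK01; sX2];
 [:: sK01; sCCX01; sCX20; sK12; sX0];
 [:: sK01; sCCX01; sCZ01; sCX12; sK01];
 [:: sK01; sCCX01; sCZ01; sK01; sX2];
 [:: sK01; sCCX01; sK01; sX2; sX1];
 [:: sK01; sCCX01; sK01; sZ0; sX0];
 [:: sK01; sCX01; sCCX12; sK12; sX0];
 [:: sK01; sCX01; sCX20; sCCX01; sK01];
 [:: sK01; sCX02; sCCX12; sK12; sX0];
 [:: sK01; sCX02; sK01; sZ0; sX0];
 [:: sK01; sCX10; sCX21; sCCX01; sK01];
 [:: sK01; sCX12; sCCX02; sCX10; sK12];
 [:: sK01; sCX12; sCX01; sCCX12; sK12];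
 [:: sK01; sCX20; sCCX01; sCX12; sK01];
 [:: sK01; sCX20; sCCX01; sCZ01; sK01];
 [:: sK01; sCX20; sCCX01; sK01; sX2];
 [:: sK01; sCX20; sCX21; sCCX01; sK01];
 [:: sK01; sCX20; sK12; sX2; sX0];
 [:: sK01; sCX20; sK12; sZ1; sX1];
 [:: sK01; sCX21; sCCX01; sCX02; sK01];
 [:: sK01; sCX21; sCCX01; sCX12; sK01];
 [:: sK01; sCX21; sCCX01; sCZ01; sK01];
 [:: sK01; sCX21; sCCX01; sK01; sX2];
 [:: sK01; sCZ02; sCCX01; sK01; sX2];
 [:: sK01; sCZ12; sCCX01; sK01; sX2];
 [:: sK01; sK12; sX2; sX1; sX0];
 [:: sK01; sK12; sX2; sZ2; sX2];
 [:: sK01; sX0; sCCX01; sK01; sX0];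
 [:: sK01; sX0; sCX01; sCCX12; sK12];
 [:: sK01; sX0; sCX02; sCCX12; sK12];
 [:: sK01; sX1; sCCX01; sCX12; sK01];
 [:: sK01; sX1; sCCX01; sK01; sX1];
 [:: sK01; sX2; sCX20; sCCX01; sK01];
 [:: sK01; sX2; sCX21; sCCX01; sK01];
 [:: sK01; sZ1; sCX21; sCCX01; sK01];
 [:: sK01; sZ2; sCCX01; sCX12; sK01];
 [:: sK12; sCCX12; sCX01; sCX12; sK01];
 [:: sK12; sCCX12; sCX02; sK01; sX1];
 [:: sK12; sCCX12; sCX10; sK12; sX0];
 [:: sK12; sCCX12; sCX20; sK12; sX0];
 [:: sK12; sCCX12; sCZ12; sK12; sX0];
 [:: sK12; sCCX12; sK12; sX1; sX0];
 [:: sK12; sCCX12; sK12; sX2; sX0];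
 [:: sK12; sCCX12; sK12; sZ1; sX1];
 [:: sK12; sCCX12; sK12; sZ2; sX2];
 [:: sK12; sCX01; sCCX12; sCX02; sK01];
 [:: sK12; sCX01; sCCX12; sCZ12; sK12];
 [:: sK12; sCX01; sCCX12; sK12; sX0];
 [:: sK12; sCX01; sCX20; sCCX01; sK01];
 [:: sK12; sCX02; sCCX12; sK12; sX0];
 [:: sK12; sCX10; sCCX02; sCX12; sK01];
 [:: sK12; sCX10; sCX21; sCCX01; sK01];
 [:: sK12; sCX12; sCX01; sCCX12; sK12];
 [:: sK12; sCX20; sCCX01; sCX12; sK01];
 [:: sK12; sCX20; sCCX01; sCZ01; sK01];
 [:: sK12; sCX20; sCCX01; sK01; sX1];
 [:: sK12; sCX20; sCCX01; sK01; sX2];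
 [:: sK12; sCX20; sCX21; sCCX01; sK01];
 [:: sK12; sCX21; sCCX01; sK01; sX2];
 [:: sK12; sCZ01; sCCX12; sK12; sX0];
 [:: sK12; sCZ02; sCCX12; sK12; sX0];
 [:: sK12; sS12; sCX20; sCCX01; sK01];
 [:: sK12; sX0; sCX01; sCCX12; sK12];
 [:: sK12; sX0; sCX02; sCCX12; sK12];
 [:: sK12; sX1; sCCX01; sK01; sX1];
 [:: sK12; sX2; sCCX12; sCX02; sK01];
 [:: sK12; sX2; sCCX12; sK12; sX2];
 [:: sK12; sX2; sCX20; sCCX01; sK01];
 [:: sK12; sX2; sCX21; sCCX01; sK01];
 [:: sK12; sZ1; sCX01; sCCX12; sK12];
 [:: sS01; sCX02; sCCX12; sK12; sX0];
 [:: sS01; sCZ01; sCCX12; sK12; sX0];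
 [:: sS01; sCZ02; sCCX12; sK12; sX0];
 [:: sS01; sCZ12; sK12; sX1; sX0];
 [:: sS01; sCZ12; sK12; sX2; sX0];
 [:: sS01; sX0; sCX01; sCCX12; sK12];
 [:: sS01; sX0; sCX02; sCCX12; sK12];
 [:: sS12; sCX20; sCCX01; sCZ01; sK01];
 [:: sS12; sX1; sCZ01; sK01; sX1];
 [:: sX0; sCCX01; sCZ01; sCX02; sK01];
 [:: sX0; sCCX02; sCX10; sK12; sX1];
 [:: sX0; sCCX02; sCZ02; sCX10; sK12];
 [:: sX0; sCX01; sCCX01; sK01; sX1];
 [:: sX0; sCX01; sCCX12; sCZ12; sK12];
 [:: sX0; sCX01; sCCX12; sK12; sX1];
 [:: sX0; sCX02; sCCX12; sCZ12; sK12];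
 [:: sX0; sCX02; sCCX12; sK12; sX2];
 [:: sX0; sCX10; sK12; sZ2; sX2];
 [:: sX0; sCX20; sCCX01; sK01; sX1];
 [:: sX0; sCX20; sK12; sZ1; sX1];
 [:: sX0; sCX21; sK12; sZ1; sX1];
 [:: sX0; sCZ02; sCCX01; sK01; sX2];
 [:: sX0; sCZ12; sK12; sZ1; sX1];
 [:: sX0; sCZ12; sK12; sZ2; sX2];
 [:: sX0; sX1; sCCX01; sK01; sX1];
 [:: sX0; sX1; sCCX12; sK12; sX1];
 [:: sX0; sX2; sCCX12; sK12; sX2];
 [:: sX0; sX2; sCZ12; sK12; sX2];
 [:: sX0; sZ0; sCCX12; sK12; sX0];
 [:: sX0; sZ0; sCX20; sCCX01; sK01];
 [:: sX0; sZ1; sCX21; sCCX01; sK01];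
 [:: sX0; sZ2; sCCX01; sK01; sX2];
 [:: sX1; sCCX01; sCZ01; sCX12; sK01];
 [:: sX1; sCCX12; sCZ02; sCX10; sK12];
 [:: sX1; sCCX12; sCZ12; sK12; sX0];
 [:: sX1; sCX01; sCCX12; sK12; sX2];
 [:: sX1; sCX12; sCCX12; sK12; sX2];
 [:: sX1; sCX12; sK01; sZ0; sX0];
 [:: sX1; sCX21; sCCX01; sK01; sX0];
 [:: sX1; sCZ01; sCCX12; sK12; sX0];
 [:: sX1; sCZ12; sCCX01; sK01; sX2];
 [:: sX1; sS01; sK12; sZ1; sX1];
 [:: sX1; sS12; sK01; sZ1; sX1];
 [:: sX1; sX0; sCCX01; sK01; sX0];
 [:: sX1; sX2; sCCX12; sK12; sX2];
 [:: sX1; sZ0; sCCX12; sK12; sX0];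
 [:: sX1; sZ1; sCCX02; sCX10; sK12];
 [:: sX1; sZ1; sCCX02; sCX12; sK01];
 [:: sX1; sZ1; sCX01; sCCX12; sK12];
 [:: sX1; sZ1; sCX21; sCCX01; sK01];
 [:: sX1; sZ2; sCCX01; sK01; sX2];
 [:: sX2; sCCX02; sCX12; sK01; sX1];
 [:: sX2; sCCX02; sCZ01; sCX12; sK01];
 [:: sX2; sCCX12; sCZ01; sCX02; sK01];
 [:: sX2; sCCX12; sCZ12; sK12; sX0];
 [:: sX2; sCX01; sCCX12; sK12; sX0];
 [:: sX2; sCX02; sCCX12; sK12; sX1];
 [:: sX2; sCX10; sK01; sZ0; sX0];
 [:: sX2; sCX20; sCCX01; sCZ01; sK01];
 [:: sX2; sCX20; sCCX01; sK01; sX0];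
 [:: sX2; sCX21; sCCX01; sCZ01; sK01];
 [:: sX2; sCX21; sCCX01; sK01; sX1];
 [:: sX2; sCZ01; sK01; sZ0; sX0];
 [:: sX2; sCZ01; sK01; sZ1; sX1];
 [:: sX2; sCZ02; sCCX12; sK12; sX0];
 [:: sX2; sX0; sCCX01; sK01; sX0];
 [:: sX2; sX1; sCCX01; sK01; sX1];
 [:: sX2; sX1; sCCX12; sK12; sX1];
 [:: sX2; sX1; sCZ01; sK01; sX1];
 [:: sX2; sZ0; sCCX12; sK12; sX0];
 [:: sX2; sZ2; sCCX01; sK01; sX2];
 [:: sX2; sZ2; sCX02; sCCX12; sK12];
 [:: sZ0; sCCX12; sCX01; sCX12; sK01];
 [:: sZ0; sCCX12; sCX02; sK01; sX1];
 [:: sZ0; sCCX12; sCX10; sK12; sX2];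
 [:: sZ0; sCX01; sCCX12; sK12; sX2];
 [:: sZ0; sCX02; sCCX12; sK12; sX1];
 [:: sZ0; sCX10; sCCX02; sCX12; sK01];
 [:: sZ0; sCX10; sCX21; sCCX01; sK01];
 [:: sZ0; sCX10; sCZ12; sK12; sX0];
 [:: sZ0; sCX12; sCX01; sCCX12; sK12];
 [:: sZ0; sCX12; sK01; sX2; sX1];
 [:: sZ0; sCX20; sCCX01; sCX12; sK01];
 [:: sZ0; sCX20; sCCX01; sK01; sX1];
 [:: sZ0; sCX20; sCCX01; sK01; sX2];
 [:: sZ0; sCX20; sCZ12; sK12; sX0];
 [:: sZ0; sX0; sCCX01; sK01; sX0];
 [:: sZ0; sX0; sCX01; sCCX12; sK12];
 [:: sZ0; sX0; sCX02; sCCX12; sK12];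
 [:: sZ0; sX1; sCCX01; sCX12; sK01];
 [:: sZ0; sX1; sCCX12; sK12; sX1];
 [:: sZ0; sX2; sCCX02; sCX12; sK01];
 [:: sZ0; sX2; sCCX12; sCX02; sK01];
 [:: sZ0; sX2; sCCX12; sK12; sX2];
 [:: sZ0; sX2; sCX20; sCCX01; sK01];
 [:: sZ0; sX2; sCX21; sCCX01; sK01];
 [:: sZ0; sZ1; sCCX02; sCX12; sK01];
 [:: sZ0; sZ1; sCX21; sCCX01; sK01];
 [:: sZ0; sZ2; sCX12; sK01; sX2];
 [:: sZ1; sCCX02; sCX01; sCX12; sK01];
 [:: sZ1; sCCX02; sCX10; sK12; sX0];
 [:: sZ1; sCCX02; sCX10; sK12; sX2];
 [:: sZ1; sCCX02; sCX12; sK01; sX2];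
 [:: sZ1; sCX01; sCCX12; sCX02; sK01];
 [:: sZ1; sCX01; sCCX12; sK12; sX0];
 [:: sZ1; sCX01; sCCX12; sK12; sX2];
 [:: sZ1; sCX01; sCX20; sCCX01; sK01];
 [:: sZ1; sCX02; sK01; sZ0; sX0];
 [:: sZ1; sCX20; sK12; sX2; sX0];
 [:: sZ1; sCX21; sCCX01; sCX02; sK01];
 [:: sZ1; sCX21; sCCX01; sK01; sX2];
 [:: sZ1; sX0; sCX01; sCCX12; sK12];
 [:: sZ1; sX0; sCX02; sCCX12; sK12];
 [:: sZ1; sX1; sCCX01; sCX12; sK01];
 [:: sZ1; sX1; sCCX01; sK01; sX1];
 [:: sZ1; sX1; sCCX12; sK12; sX1];
 [:: sZ1; sX2; sCCX02; sCX12; sK01];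
 [:: sZ1; sX2; sCCX12; sCX02; sK01];
 [:: sZ1; sX2; sCX20; sCCX01; sK01];
 [:: sZ1; sX2; sCX21; sCCX01; sK01];
 [:: sZ1; sZ2; sCX02; sCCX12; sK12];
 [:: sZ2; sCCX01; sCX01; sCX12; sK01];
 [:: sZ2; sCX02; sCCX12; sCX10; sK12];
 [:: sZ2; sCX02; sCCX12; sK12; sX0];
 [:: sZ2; sCX10; sCX21; sCCX01; sK01];
 [:: sZ2; sCX10; sK12; sX1; sX0];
 [:: sZ2; sCX10; sK12; sZ1; sX1];
 [:: sZ2; sCX12; sCCX02; sCX10; sK12];
 [:: sZ2; sCX12; sCX01; sCCX12; sK12];
 [:: sZ2; sCX20; sCCX01; sK01; sX1];
 [:: sZ2; sCX21; sCCX01; sK01; sX0];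
 [:: sZ2; sX0; sCCX01; sK01; sX0];
 [:: sZ2; sX0; sCX01; sCCX12; sK12];
 [:: sZ2; sX0; sCX02; sCCX12; sK12];
 [:: sZ2; sX1; sCCX01; sCX12; sK01];
 [:: sZ2; sX1; sCCX01; sK01; sX1];
 [:: sZ2; sX2; sCCX02; sCX12; sK01];
 [:: sZ2; sX2; sCCX12; sCX02; sK01];
 [:: sZ2; sX2; sCCX12; sK12; sX2];
 [:: sZ2; sX2; sCX20; sCCX01; sK01];
 [:: sZ2; sX2; sCX21; sCCX01; sK01];
 [:: sCCX01; sCX01; sCX12; sK01; sX2; sX1];
 [:: sCCX01; sCX01; sCX12; sK01; sZ2; sX2];
 [:: sCCX01; sCX10; sCX02; sK01; sZ0; sX0];
 [:: sCCX01; sCZ01; sCX02; sK01; sZ0; sX0];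
 [:: sCCX01; sCZ01; sCX12; sK01; sZ1; sX1];
 [:: sCCX01; sCZ02; sCX12; sK01; sX2; sX1];
 [:: sCCX01; sCZ02; sCX12; sK01; sZ2; sX2];
 [:: sCCX01; sCZ12; sCX02; sK01; sZ2; sX2];
 [:: sCCX01; sX2; sCX10; sK01; sZ0; sX0];
 [:: sCCX01; sX2; sX1; sCZ01; sK01; sX1];
 [:: sCCX01; sZ0; sCX20; sCZ12; sK12; sX0];
 [:: sCCX01; sZ0; sZ2; sCX12; sK01; sX2];
 [:: sCCX01; sZ1; sCX20; sK12; sX2; sX0];
 [:: sCCX02; sCX01; sCX12; sK01; sZ2; sX2];
 [:: sCCX02; sCX02; sCX10; sK12; sX2; sX0];
 [:: sCCX02; sCX02; sZ2; sCX12; sK01; sX2];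
 [:: sCCX02; sCX10; sCX02; sK01; sZ0; sX0];
 [:: sCCX02; sCX10; sCX12; sK01; sZ0; sX0];
 [:: sCCX02; sCX10; sCZ12; sK12; sZ2; sX2];
 [:: sCCX02; sCX10; sK12; sX2; sZ2; sX2];
 [:: sCCX02; sCX10; sX2; sCZ12; sK12; sX2];
 [:: sCCX02; sCX12; sCZ01; sK01; sZ0; sX0];
 [:: sCCX02; sCX12; sK01; sX2; sZ2; sX2];
 [:: sCCX02; sCX12; sX1; sCZ01; sK01; sX1];
 [:: sCCX02; sCX20; sCX10; sK12; sX1; sX0];
 [:: sCCX02; sCX20; sCX10; sK12; sZ1; sX1];
 [:: sCCX02; sCX20; sS01; sK12; sZ1; sX1];
 [:: sCCX02; sCX21; sCX10; sK12; sZ1; sX1];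
 [:: sCCX02; sCZ01; sCX12; sK01; sX2; sX1];
 [:: sCCX02; sCZ01; sCX12; sK01; sZ1; sX1];
 [:: sCCX02; sCZ01; sCX12; sK01; sZ2; sX2];
 [:: sCCX02; sCZ01; sZ2; sCX12; sK01; sX2];
 [:: sCCX02; sCZ02; sCX10; sK12; sZ0; sX0];
 [:: sCCX02; sCZ02; sCX10; sK12; sZ1; sX1];
 [:: sCCX02; sCZ02; sCX12; sK01; sZ2; sX2];
 [:: sCCX02; sCZ02; sS01; sK12; sZ1; sX1];
 [:: sCCX02; sCZ12; sCX10; sK12; sX1; sX0];
 [:: sCCX02; sCZ12; sCX10; sK12; sZ0; sX0];
 [:: sCCX02; sK01; sCX02; sK01; sZ0; sX0];
 [:: sCCX02; sK01; sCX20; sK12; sX2; sX0];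
 [:: sCCX02; sK01; sK12; sX2; sX1; sX0];
 [:: sCCX02; sK01; sK12; sX2; sZ2; sX2];
 [:: sCCX02; sS12; sX1; sCZ01; sK01; sX1];
 [:: sCCX02; sX0; sCX10; sK12; sZ2; sX2];
 [:: sCCX02; sX1; sCX12; sK01; sZ0; sX0];
 [:: sCCX02; sX1; sS01; sK12; sZ1; sX1];
 [:: sCCX02; sX1; sS12; sK01; sZ1; sX1];
 [:: sCCX02; sZ0; sCX10; sCZ12; sK12; sX0];
 [:: sCCX02; sZ0; sCX12; sK01; sX2; sX1];
 [:: sCCX02; sZ0; sZ2; sCX12; sK01; sX2];
 [:: sCCX02; sZ2; sCX10; sK12; sX1; sX0];
 [:: sCCX02; sZ2; sCX10; sK12; sZ1; sX1];
 [:: sCCX12; sCX01; sCX12; sK01; sZ2; sX2];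
 [:: sCCX12; sCX02; sCX10; sK12; sX2; sX0];
 [:: sCCX12; sCX02; sK01; sX2; sX1; sX0];
 [:: sCCX12; sCX12; sCX20; sK12; sX2; sX0];
 [:: sCCX12; sCX21; sCX10; sK12; sZ1; sX1];
 [:: sCCX12; sCZ01; sCX02; sK01; sZ0; sX0];
 [:: sCCX12; sCZ01; sCX02; sK01; sZ2; sX2];
 [:: sCCX12; sCZ01; sCX20; sK12; sX2; sX0];
 [:: sCCX12; sCZ02; sCX10; sK12; sX1; sX0];
 [:: sCCX12; sCZ02; sCX10; sK12; sZ0; sX0];
 [:: sCCX12; sCZ02; sCX10; sK12; sZ1; sX1];
 [:: sCCX12; sX0; sCX21; sK12; sZ1; sX1];
 [:: sCCX12; sX0; sX2; sCZ12; sK12; sX2];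
 [:: sCX01; sCCX12; sCX02; sK01; sZ0; sX0];
 [:: sCX01; sCCX12; sCX02; sK01; sZ2; sX2];
 [:: sCX01; sCCX12; sCZ12; sK12; sZ1; sX1];
 [:: sCX01; sCCX12; sCZ12; sK12; sZ2; sX2];
 [:: sCX01; sCCX12; sK12; sX2; sZ2; sX2];
 [:: sCX01; sCX02; sCZ02; sCCX12; sK12; sX0];
 [:: sCX01; sCX02; sZ0; sCCX12; sK12; sX0];
 [:: sCX01; sCX12; sCCX12; sK12; sX2; sX0];
 [:: sCX01; sCX12; sCCX12; sK12; sZ2; sX2];
 [:: sCX01; sCX20; sCCX01; sK01; sX2; sX0];
 [:: sCX01; sCX20; sCCX01; sK01; sX2; sX1];
 [:: sCX01; sCX20; sCCX01; sK01; sZ0; sX0];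
 [:: sCX01; sCX20; sCCX01; sK01; sZ1; sX1];
 [:: sCX01; sCX20; sCCX01; sK01; sZ2; sX2];
 [:: sCX01; sCX20; sCZ02; sCCX01; sK01; sX2];
 [:: sCX01; sCX20; sK12; sCX01; sCCX12; sK12];
 [:: sCX01; sCX20; sX2; sCCX12; sK12; sX2];
 [:: sCX01; sCX20; sZ0; sCCX12; sK12; sX0];
 [:: sCX01; sCX21; sCCX01; sK01; sX2; sX1];
 [:: sCX01; sCX21; sCCX01; sK01; sZ1; sX1];
 [:: sCX01; sCX21; sCCX12; sK12; sX1; sX0];
 [:: sCX01; sCX21; sCZ12; sCCX01; sK01; sX2];
 [:: sCX01; sCZ01; sCX12; sK01; sZ1; sX1];
 [:: sCX01; sCZ01; sCX12; sK01; sZ2; sX2];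
 [:: sCX01; sCZ02; sK01; sCCX01; sK01; sX1];
 [:: sCX01; sCZ12; sK01; sCCX01; sK01; sX1];
 [:: sCX01; sCZ12; sK12; sCCX12; sK12; sX0];
 [:: sCX01; sCZ12; sX1; sCCX12; sK12; sX1];
 [:: sCX01; sCZ12; sX2; sCCX12; sK12; sX2];
 [:: sCX01; sK01; sCCX01; sCZ01; sK01; sX2];
 [:: sCX01; sK01; sCCX01; sK01; sX2; sX1];
 [:: sCX01; sK01; sZ1; sCX21; sCCX01; sK01];
 [:: sCX01; sX0; sCX02; sCCX12; sCZ12; sK12];
 [:: sCX01; sX0; sCX02; sCCX12; sK12; sX2];
 [:: sCX01; sX0; sX2; sCCX12; sK12; sX2];
 [:: sCX01; sX0; sZ0; sCCX12; sK12; sX0];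
 [:: sCX01; sX0; sZ0; sCX20; sCCX01; sK01];
 [:: sCX01; sX1; sCX12; sCCX12; sK12; sX2];
 [:: sCX01; sX2; sCCX12; sCZ01; sCX02; sK01];
 [:: sCX01; sX2; sCX20; sCCX01; sCZ01; sK01];
 [:: sCX01; sX2; sCX20; sCCX01; sK01; sX0];
 [:: sCX01; sX2; sCX21; sCCX01; sK01; sX1];
 [:: sCX01; sX2; sZ2; sCX02; sCCX12; sK12];
 [:: sCX01; sZ0; sX2; sCX20; sCCX01; sK01];
 [:: sCX01; sZ1; sX0; sCX02; sCCX12; sK12];
 [:: sCX01; sZ1; sX1; sCCX12; sK12; sX1];
 [:: sCX01; sZ1; sX2; sCX20; sCCX01; sK01];
 [:: sCX01; sZ2; sX0; sCX02; sCCX12; sK12];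
 [:: sCX01; sZ2; sX2; sCCX12; sK12; sX2];
 [:: sCX02; sCCX12; sCX10; sK12; sZ0; sX0];
 [:: sCX02; sCCX12; sCX10; sK12; sZ1; sX1];
 [:: sCX02; sCCX12; sCZ12; sK12; sZ1; sX1];
 [:: sCX02; sCCX12; sCZ12; sK12; sZ2; sX2];
 [:: sCX02; sCCX12; sK12; sX2; sZ2; sX2];
 [:: sCX02; sCX01; sCCX12; sK12; sX1; sX0];
 [:: sCX02; sCX01; sX2; sCCX12; sK12; sX2];
 [:: sCX02; sCX10; sX1; sCCX12; sK12; sX1];
 [:: sCX02; sCX10; sZ0; sCCX12; sK12; sX0];
 [:: sCX02; sCX12; sCCX12; sK12; sX2; sX0];
 [:: sCX02; sCX12; sK01; sCCX01; sK01; sX1];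
 [:: sCX02; sCX21; sCCX01; sK01; sX2; sX1];
 [:: sCX02; sCX21; sCCX01; sK01; sZ1; sX1];
 [:: sCX02; sCZ01; sK01; sCCX01; sK01; sX2];
 [:: sCX02; sCZ12; sK01; sCCX01; sK01; sX1];
 [:: sCX02; sCZ12; sK12; sCCX12; sK12; sX0];
 [:: sCX02; sCZ12; sX1; sCCX12; sK12; sX1];
 [:: sCX02; sCZ12; sX2; sCCX12; sK12; sX2];
 [:: sCX02; sK01; sCCX01; sK01; sZ0; sX0];
 [:: sCX02; sK01; sCX01; sCX20; sCCX01; sK01];
 [:: sCX02; sK01; sCX10; sCX21; sCCX01; sK01];
 [:: sCX02; sK01; sCX12; sCX01; sCCX12; sK12];
 [:: sCX02; sK01; sCX21; sCCX01; sCX02; sK01];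
 [:: sCX02; sK01; sCX21; sCCX01; sK01; sX2];
 [:: sCX02; sK01; sX2; sCX21; sCCX01; sK01];
 [:: sCX02; sK12; sCCX12; sCX02; sK01; sX1];
 [:: sCX02; sK12; sCCX12; sK12; sX1; sX0];
 [:: sCX02; sX0; sCX01; sCCX12; sK12; sX1];
 [:: sCX02; sX0; sX1; sCCX12; sK12; sX1];
 [:: sCX02; sX0; sZ0; sCCX12; sK12; sX0];
 [:: sCX02; sX0; sZ0; sCX20; sCCX01; sK01];
 [:: sCX02; sX2; sCX21; sCCX01; sK01; sX1];
 [:: sCX02; sX2; sZ2; sCCX01; sK01; sX2];
 [:: sCX02; sZ1; sCX01; sCCX12; sK12; sX0];
 [:: sCX02; sZ1; sCX01; sCCX12; sK12; sX2];
 [:: sCX02; sZ1; sX1; sCCX12; sK12; sX1];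
 [:: sCX02; sZ2; sX0; sCCX01; sK01; sX0];
 [:: sCX02; sZ2; sX2; sCCX12; sK12; sX2];
 [:: sCX02; sZ2; sX2; sCX20; sCCX01; sK01];
 [:: sCX10; sCCX02; sCX12; sK01; sZ0; sX0];
 [:: sCX10; sCCX02; sCX12; sK01; sZ2; sX2];
 [:: sCX10; sCCX02; sS01; sK12; sZ1; sX1];
 [:: sCX10; sCX02; sCCX12; sK12; sX2; sX0];
 [:: sCX10; sCX20; sCCX01; sK01; sX2; sX0];
 [:: sCX10; sCX20; sCCX01; sK01; sZ0; sX0];
 [:: sCX10; sCX20; sCZ02; sCCX01; sK01; sX2];
 [:: sCX10; sCX21; sCCX01; sK01; sX1; sX0];
 [:: sCX10; sCX21; sCCX01; sK01; sX2; sX1];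
 [:: sCX10; sCX21; sCCX01; sK01; sZ0; sX0];
 [:: sCX10; sCX21; sCCX01; sK01; sZ1; sX1];
 [:: sCX10; sCX21; sCCX01; sK01; sZ2; sX2];
 [:: sCX10; sCX21; sCZ02; sCCX01; sK01; sX2];
 [:: sCX10; sCX21; sCZ12; sCCX01; sK01; sX2];
 [:: sCX10; sCX21; sX0; sCCX01; sK01; sX0];
 [:: sCX10; sCX21; sZ2; sCCX01; sK01; sX2];
 [:: sCX10; sCZ01; sCX02; sK01; sZ0; sX0];
 [:: sCX10; sCZ01; sCX02; sK01; sZ2; sX2];
 [:: sCX10; sCZ02; sK01; sCCX01; sK01; sX1];
 [:: sCX10; sCZ12; sCX21; sCCX01; sK01; sX2];
 [:: sCX10; sCZ12; sK12; sCCX12; sK12; sX0];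
 [:: sCX10; sCZ12; sK12; sX2; sZ2; sX2];
 [:: sCX10; sK01; sCCX01; sCZ01; sK01; sX2];
 [:: sCX10; sK01; sZ1; sCX21; sCCX01; sK01];
 [:: sCX10; sK12; sCCX12; sK12; sX2; sX0];
 [:: sCX10; sK12; sCX02; sCCX12; sK12; sX0];
 [:: sCX10; sK12; sCX10; sCX21; sCCX01; sK01];
 [:: sCX10; sK12; sCX20; sCCX01; sK01; sX1];
 [:: sCX10; sK12; sCX20; sCX21; sCCX01; sK01];
 [:: sCX10; sK12; sX0; sCX02; sCCX12; sK12];
 [:: sCX10; sX0; sZ0; sCCX12; sK12; sX0];
 [:: sCX10; sX0; sZ0; sCX20; sCCX01; sK01];
 [:: sCX10; sX1; sZ1; sCX21; sCCX01; sK01];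
 [:: sCX10; sX2; sCX20; sCCX01; sK01; sX0];
 [:: sCX10; sX2; sCX21; sCCX01; sK01; sX1];
 [:: sCX10; sZ1; sCX21; sCCX01; sK01; sX2];
 [:: sCX10; sZ1; sX2; sCX21; sCCX01; sK01];
 [:: sCX10; sZ2; sX2; sCX21; sCCX01; sK01];
 [:: sCX12; sCCX02; sCX10; sCZ12; sK12; sX0];
 [:: sCX12; sCCX02; sCX10; sK12; sZ0; sX0];
 [:: sCX12; sCCX02; sCX10; sK12; sZ1; sX1];
 [:: sCX12; sCX01; sCCX12; sK12; sX2; sX1];
 [:: sCX12; sCX01; sCCX12; sK12; sZ0; sX0];
 [:: sCX12; sCX01; sCCX12; sK12; sZ1; sX1];
 [:: sCX12; sCX01; sCCX12; sK12; sZ2; sX2];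
 [:: sCX12; sCX01; sCZ01; sCCX12; sK12; sX0];
 [:: sCX12; sCX01; sCZ02; sCCX12; sK12; sX0];
 [:: sCX12; sCX01; sZ0; sCCX12; sK12; sX0];
 [:: sCX12; sCX02; sCCX12; sK12; sZ2; sX2];
 [:: sCX12; sCX02; sCZ02; sCCX12; sK12; sX0];
 [:: sCX12; sCX20; sCCX01; sK01; sX2; sX0];
 [:: sCX12; sCX20; sCCX01; sK01; sZ0; sX0];
 [:: sCX12; sCX20; sK12; sCX01; sCCX12; sK12];
 [:: sCX12; sCZ01; sCX01; sCCX12; sK12; sX0];
 [:: sCX12; sCZ01; sK01; sCCX01; sK01; sX2];
 [:: sCX12; sCZ01; sK01; sX2; sZ2; sX2];
 [:: sCX12; sCZ02; sK01; sCCX01; sK01; sX1];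
 [:: sCX12; sK01; sCX20; sCCX01; sK01; sX2];
 [:: sCX12; sK01; sX2; sCX20; sCCX01; sK01];
 [:: sCX12; sK12; sCCX12; sCZ12; sK12; sX0];
 [:: sCX12; sK12; sCCX12; sK12; sX1; sX0];
 [:: sCX12; sK12; sCX20; sCCX01; sK01; sX1];
 [:: sCX12; sK12; sZ1; sCX01; sCCX12; sK12];
 [:: sCX12; sX0; sCX02; sCCX12; sK12; sX2];
 [:: sCX12; sX1; sZ1; sCX21; sCCX01; sK01];
 [:: sCX12; sX2; sCX20; sCCX01; sK01; sX0];
 [:: sCX12; sX2; sZ2; sCCX01; sK01; sX2];
 [:: sCX12; sZ1; sCX01; sCCX12; sK12; sX0];
 [:: sCX12; sZ1; sX1; sCCX01; sK01; sX1];
 [:: sCX12; sZ2; sX0; sCX01; sCCX12; sK12];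
 [:: sCX20; sCCX01; sCX12; sK01; sZ2; sX2];
 [:: sCX20; sCCX01; sCZ01; sK01; sZ0; sX0];
 [:: sCX20; sCX01; sCCX01; sK01; sZ1; sX1];
 [:: sCX20; sCX01; sCCX12; sK12; sX1; sX0];
 [:: sCX20; sCX01; sCCX12; sK12; sZ1; sX1];
 [:: sCX20; sCX10; sK01; sCCX01; sK01; sX1];
 [:: sCX20; sCX10; sK12; sX2; sZ2; sX2];
 [:: sCX20; sCX12; sZ2; sCCX01; sK01; sX2];
 [:: sCX20; sCX21; sCCX01; sK01; sX2; sX1];
 [:: sCX20; sCX21; sCCX01; sK01; sZ0; sX0];
 [:: sCX20; sCX21; sCCX01; sK01; sZ1; sX1];
 [:: sCX20; sCX21; sCCX01; sK01; sZ2; sX2];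
 [:: sCX20; sCX21; sCZ12; sCCX01; sK01; sX2];
 [:: sCX20; sCX21; sX0; sCCX01; sK01; sX0];
 [:: sCX20; sCX21; sZ2; sCCX01; sK01; sX2];
 [:: sCX20; sCZ01; sK01; sCCX01; sK01; sX1];
 [:: sCX20; sCZ01; sK01; sCCX01; sK01; sX2];
 [:: sCX20; sCZ01; sX0; sCCX01; sK01; sX0];
 [:: sCX20; sCZ02; sCX10; sK12; sZ0; sX0];
 [:: sCX20; sCZ02; sCX10; sK12; sZ1; sX1];
 [:: sCX20; sCZ12; sK12; sCCX12; sK12; sX0];
 [:: sCX20; sCZ12; sK12; sX2; sZ2; sX2];
 [:: sCX20; sK12; sCCX12; sCX02; sK01; sX1];
 [:: sCX20; sK12; sCCX12; sK12; sX1; sX0];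
 [:: sCX20; sK12; sCCX12; sK12; sZ2; sX2];
 [:: sCX20; sK12; sCX01; sCCX12; sK12; sX0];
 [:: sCX20; sK12; sX0; sCX01; sCCX12; sK12];
 [:: sCX20; sX0; sCX01; sCCX01; sK01; sX1];
 [:: sCX20; sX0; sCX01; sCCX12; sK12; sX1];
 [:: sCX20; sX0; sZ0; sCCX12; sK12; sX0];
 [:: sCX20; sX1; sCZ12; sCCX01; sK01; sX2];
 [:: sCX20; sX2; sX1; sCCX01; sK01; sX1];
 [:: sCX20; sX2; sZ2; sCCX01; sK01; sX2];
 [:: sCX20; sZ0; sX0; sCCX01; sK01; sX0];
 [:: sCX20; sZ2; sX2; sCCX12; sK12; sX2];
 [:: sCX21; sCCX01; sCX02; sK01; sZ0; sX0];
 [:: sCX21; sCCX01; sCX02; sK01; sZ2; sX2];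
 [:: sCX21; sCCX01; sCX12; sK01; sZ1; sX1];
 [:: sCX21; sCCX01; sCZ01; sK01; sZ0; sX0];
 [:: sCX21; sCCX01; sCZ01; sK01; sZ1; sX1];
 [:: sCX21; sCCX01; sK01; sX2; sZ2; sX2];
 [:: sCX21; sCCX01; sZ2; sCX12; sK01; sX2];
 [:: sCX21; sCX01; sCCX12; sK12; sZ1; sX1];
 [:: sCX21; sCX01; sCZ01; sCCX12; sK12; sX0];
 [:: sCX21; sCX02; sCCX12; sK12; sZ1; sX1];
 [:: sCX21; sCX02; sCZ01; sCCX12; sK12; sX0];
 [:: sCX21; sCX02; sCZ02; sCCX12; sK12; sX0];
 [:: sCX21; sCX02; sZ0; sCCX12; sK12; sX0];
 [:: sCX21; sCX02; sZ2; sCCX01; sK01; sX2];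
 [:: sCX21; sCX10; sCCX01; sK01; sX2; sX0];
 [:: sCX21; sCX10; sCCX01; sK01; sZ0; sX0];
 [:: sCX21; sCX12; sX1; sCCX01; sK01; sX1];
 [:: sCX21; sCX20; sCCX01; sK01; sX2; sX0];
 [:: sCX21; sCX20; sCZ02; sCCX01; sK01; sX2];
 [:: sCX21; sCZ01; sK01; sCCX01; sK01; sX1];
 [:: sCX21; sCZ01; sK01; sCCX01; sK01; sX2];
 [:: sCX21; sCZ01; sX1; sCCX01; sK01; sX1];
 [:: sCX21; sCZ02; sCX02; sCCX12; sK12; sX0];
 [:: sCX21; sCZ02; sK01; sCCX01; sK01; sX1];
 [:: sCX21; sK12; sCCX12; sCZ12; sK12; sX0];
 [:: sCX21; sK12; sCCX12; sK12; sX2; sX0];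
 [:: sCX21; sK12; sZ1; sCX01; sCCX12; sK12];
 [:: sCX21; sX0; sCX01; sCCX01; sK01; sX1];
 [:: sCX21; sX0; sCX01; sCCX12; sK12; sX1];
 [:: sCX21; sX0; sCZ02; sCCX01; sK01; sX2];
 [:: sCX21; sX1; sZ1; sCX01; sCCX12; sK12];
 [:: sCX21; sX2; sX0; sCCX01; sK01; sX0];
 [:: sCX21; sX2; sZ2; sCCX01; sK01; sX2];
 [:: sCX21; sZ1; sX0; sCX02; sCCX12; sK12];
 [:: sCX21; sZ1; sX1; sCCX01; sK01; sX1];
 [:: sCX21; sZ2; sX1; sCCX01; sCX12; sK01];
 [:: sCZ01; sCX01; sCX12; sK01; sZ2; sX2];
 [:: sCZ01; sCX02; sCCX12; sK12; sX2; sX0];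
 [:: sCZ01; sCX02; sCCX12; sK12; sZ0; sX0];
 [:: sCZ01; sCX02; sCX01; sCCX12; sK12; sX0];
 [:: sCZ01; sCX02; sX0; sCCX01; sK01; sX0];
 [:: sCZ01; sCX10; sK01; sCCX01; sK01; sX1];
 [:: sCZ01; sCX12; sK01; sCCX01; sK01; sX1];
 [:: sCZ01; sCZ02; sK01; sCCX01; sK01; sX1];
 [:: sCZ01; sCZ12; sK01; sCCX01; sK01; sX1];
 [:: sCZ01; sCZ12; sK12; sCCX12; sK12; sX0];
 [:: sCZ01; sK01; sCCX01; sCX01; sCX12; sK01];
 [:: sCZ01; sK01; sCCX01; sK01; sX2; sX1];
 [:: sCZ01; sK01; sCCX01; sK01; sZ0; sX0];
 [:: sCZ01; sK01; sCX20; sCCX01; sK01; sX2];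
 [:: sCZ01; sK01; sCX21; sCCX01; sCX02; sK01];
 [:: sCZ01; sK01; sCX21; sCCX01; sK01; sX2];
 [:: sCZ01; sK01; sCZ02; sCCX01; sK01; sX2];
 [:: sCZ01; sK01; sCZ12; sCCX01; sK01; sX2];
 [:: sCZ01; sK01; sX2; sCX20; sCCX01; sK01];
 [:: sCZ01; sK01; sX2; sCX21; sCCX01; sK01];
 [:: sCZ01; sK12; sCCX12; sCX02; sK01; sX1];
 [:: sCZ01; sK12; sCCX12; sCZ12; sK12; sX0];
 [:: sCZ01; sK12; sCCX12; sK12; sX1; sX0];
 [:: sCZ01; sK12; sCCX12; sK12; sX2; sX0];
 [:: sCZ01; sK12; sCX20; sCCX01; sK01; sX1];
 [:: sCZ01; sX0; sCX02; sCCX12; sK12; sX2];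
 [:: sCZ01; sX0; sX1; sCCX01; sK01; sX1];
 [:: sCZ01; sX1; sX0; sCCX01; sK01; sX0];
 [:: sCZ02; sCX01; sCCX12; sK12; sX1; sX0];
 [:: sCZ02; sCX01; sCCX12; sK12; sZ0; sX0];
 [:: sCZ02; sCX02; sCX01; sCCX12; sK12; sX0];
 [:: sCZ02; sCX21; sCCX01; sK01; sX2; sX1];
 [:: sCZ02; sCX21; sCCX01; sK01; sZ2; sX2];
 [:: sCZ02; sCZ12; sK01; sCCX01; sK01; sX1];
 [:: sCZ02; sCZ12; sK12; sCCX12; sK12; sX0];
 [:: sCZ02; sK01; sCCX01; sCZ01; sCX12; sK01];
 [:: sCZ02; sK01; sCCX01; sCZ01; sK01; sX2];
 [:: sCZ02; sK01; sCCX01; sK01; sX2; sX1];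
 [:: sCZ02; sK01; sZ1; sCX21; sCCX01; sK01];
 [:: sCZ02; sK12; sCCX12; sCZ12; sK12; sX0];
 [:: sCZ02; sK12; sCCX12; sK12; sX1; sX0];
 [:: sCZ02; sK12; sCCX12; sK12; sX2; sX0];
 [:: sCZ02; sK12; sZ1; sCX01; sCCX12; sK12];
 [:: sCZ02; sX0; sCCX02; sCX10; sK12; sX1];
 [:: sCZ02; sX2; sCCX02; sCX12; sK01; sX1];
 [:: sCZ02; sX2; sCX21; sCCX01; sK01; sX1];
 [:: sCZ12; sCX02; sCX01; sCCX12; sK12; sX0];
 [:: sCZ12; sCX10; sK01; sCCX01; sK01; sX1];
 [:: sCZ12; sCX10; sX1; sCCX12; sK12; sX1];
 [:: sCZ12; sCX12; sK01; sCCX01; sK01; sX1];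
 [:: sCZ12; sCX20; sCCX01; sK01; sX2; sX0];
 [:: sCZ12; sCX20; sCCX01; sK01; sZ2; sX2];
 [:: sCZ12; sCX21; sCX10; sK12; sZ1; sX1];
 [:: sCZ12; sK01; sCCX01; sCZ01; sK01; sX2];
 [:: sCZ12; sK01; sCCX01; sK01; sX2; sX1];
 [:: sCZ12; sK12; sCCX12; sCX01; sCX12; sK01];
 [:: sCZ12; sK12; sCCX12; sCX02; sK01; sX1];
 [:: sCZ12; sK12; sCCX12; sCZ12; sK12; sX0];
 [:: sCZ12; sK12; sCCX12; sK12; sX1; sX0];
 [:: sCZ12; sK12; sCCX12; sK12; sX2; sX0];
 [:: sCZ12; sK12; sCCX12; sK12; sZ2; sX2];
 [:: sCZ12; sK12; sCX20; sCCX01; sK01; sX1];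
 [:: sCZ12; sK12; sCZ01; sCCX12; sK12; sX0];
 [:: sCZ12; sK12; sCZ02; sCCX12; sK12; sX0];
 [:: sCZ12; sK12; sX0; sCX01; sCCX12; sK12];
 [:: sCZ12; sK12; sX0; sCX02; sCCX12; sK12];
 [:: sK01; sCCX01; sCX02; sCZ01; sK01; sX2];
 [:: sK01; sCCX01; sCX02; sK01; sZ0; sX0];
 [:: sK01; sCCX01; sCX10; sK01; sZ0; sX0];
 [:: sK01; sCCX01; sCX12; sCZ01; sK01; sX2];
 [:: sK01; sCCX01; sCX20; sCZ12; sK12; sX0];
 [:: sK01; sCCX01; sCX20; sK12; sX2; sX0];
 [:: sK01; sCCX01; sCZ01; sK01; sZ0; sX0];
 [:: sK01; sCCX01; sCZ12; sCX01; sCX12; sK01];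
 [:: sK01; sCCX01; sX1; sCZ01; sK01; sX1];
 [:: sK01; sCX01; sCCX01; sK01; sZ1; sX1];
 [:: sK01; sCX01; sCCX12; sK12; sZ1; sX1];
 [:: sK01; sCX01; sCZ01; sCCX12; sK12; sX0];
 [:: sK01; sCX01; sCZ02; sCCX12; sK12; sX0];
 [:: sK01; sCX01; sX1; sCCX12; sK12; sX1];
 [:: sK01; sCX01; sZ2; sCX02; sCCX12; sK12];
 [:: sK01; sCX02; sCCX12; sCZ12; sK12; sX0];
 [:: sK01; sCX02; sCCX12; sK12; sX1; sX0];
 [:: sK01; sCX02; sCCX12; sK12; sZ1; sX1];
 [:: sK01; sCX02; sCCX12; sK12; sZ2; sX2];
 [:: sK01; sCX02; sCX01; sCCX12; sK12; sX0];
 [:: sK01; sCX02; sCZ01; sCCX12; sK12; sX0];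
 [:: sK01; sCX02; sCZ02; sCCX12; sK12; sX0];
 [:: sK01; sCX02; sX0; sCCX01; sK01; sX0];
 [:: sK01; sCX02; sX2; sCCX12; sK12; sX2];
 [:: sK01; sCX10; sCCX01; sK01; sZ0; sX0];
 [:: sK01; sCX10; sCX21; sCCX01; sK01; sX2];
 [:: sK01; sCX12; sCCX02; sCX10; sK12; sX2];
 [:: sK01; sCX12; sCCX02; sCZ02; sCX10; sK12];
 [:: sK01; sCX12; sCX01; sCCX12; sK12; sX0];
 [:: sK01; sCX12; sCX01; sCCX12; sK12; sX1];
 [:: sK01; sCX12; sCX01; sCCX12; sK12; sX2];
 [:: sK01; sCX12; sX1; sCCX01; sK01; sX1];
 [:: sK01; sCX20; sCCX01; sK01; sZ0; sX0];
 [:: sK01; sCX20; sCZ02; sCCX01; sK01; sX2];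
 [:: sK01; sCX20; sCZ12; sCCX01; sK01; sX2];
 [:: sK01; sCX20; sX0; sCCX01; sK01; sX0];
 [:: sK01; sCX20; sZ2; sCCX01; sCX12; sK01];
 [:: sK01; sCX21; sCCX01; sK01; sZ0; sX0];
 [:: sK01; sCX21; sCCX01; sK01; sZ1; sX1];
 [:: sK01; sCX21; sCCX12; sK12; sX1; sX0];
 [:: sK01; sCX21; sCCX12; sK12; sZ1; sX1];
 [:: sK01; sCX21; sCX02; sCCX12; sK12; sX0];
 [:: sK01; sCX21; sCZ02; sCCX01; sK01; sX2];
 [:: sK01; sCX21; sCZ12; sCCX01; sK01; sX2];
 [:: sK01; sCX21; sX0; sCCX01; sK01; sX0];
 [:: sK01; sCX21; sX1; sCCX01; sK01; sX1];
 [:: sK01; sCX21; sZ2; sCCX01; sCX02; sK01];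
 [:: sK01; sCX21; sZ2; sCCX01; sK01; sX2];
 [:: sK01; sCX21; sZ2; sCX02; sCCX12; sK12];
 [:: sK01; sCZ01; sX0; sCCX01; sK01; sX0];
 [:: sK01; sCZ01; sX0; sCX02; sCCX12; sK12];
 [:: sK01; sCZ01; sX1; sCCX01; sCX12; sK01];
 [:: sK01; sCZ02; sCX02; sCCX12; sK12; sX0];
 [:: sK01; sCZ02; sX2; sCX21; sCCX01; sK01];
 [:: sK01; sCZ12; sCX21; sCCX01; sK01; sX2];
 [:: sK01; sCZ12; sX2; sCX20; sCCX01; sK01];
 [:: sK01; sK12; sCX01; sCCX12; sK12; sX0];
 [:: sK01; sK12; sX0; sCX01; sCCX12; sK12];
 [:: sK01; sS01; sCX02; sCCX12; sK12; sX0];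
 [:: sK01; sS01; sX0; sCX02; sCCX12; sK12];
 [:: sK01; sX0; sCCX01; sCZ01; sCX02; sK01];
 [:: sK01; sX0; sCX01; sCCX01; sK01; sX1];
 [:: sK01; sX0; sCX01; sCCX12; sK12; sX1];
 [:: sK01; sX0; sCX02; sCCX12; sCZ12; sK12];
 [:: sK01; sX0; sCX02; sCCX12; sK12; sX2];
 [:: sK01; sX0; sCZ02; sCCX01; sK01; sX2];
 [:: sK01; sX0; sZ0; sCX20; sCCX01; sK01];
 [:: sK01; sX1; sCZ12; sCCX01; sK01; sX2];
 [:: sK01; sX1; sX0; sCCX01; sK01; sX0];
 [:: sK01; sX1; sZ1; sCX01; sCCX12; sK12];
 [:: sK01; sX1; sZ1; sCX21; sCCX01; sK01];
 [:: sK01; sX1; sZ2; sCCX01; sK01; sX2];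
 [:: sK01; sX2; sCX20; sCCX01; sCZ01; sK01];
 [:: sK01; sX2; sCX21; sCCX01; sCZ01; sK01];
 [:: sK01; sX2; sCX21; sCCX01; sK01; sX1];
 [:: sK01; sX2; sZ2; sCX02; sCCX12; sK12];
 [:: sK01; sZ0; sCX10; sCX21; sCCX01; sK01];
 [:: sK01; sZ0; sX2; sCX21; sCCX01; sK01];
 [:: sK01; sZ1; sCX01; sCX20; sCCX01; sK01];
 [:: sK01; sZ1; sCX02; sK01; sZ0; sX0];
 [:: sK01; sZ1; sCX20; sK12; sX2; sX0];
 [:: sK01; sZ1; sCX21; sCCX01; sCX02; sK01];
 [:: sK01; sZ1; sCX21; sCCX01; sK01; sX2];
 [:: sK01; sZ1; sX0; sCX01; sCCX12; sK12];
 [:: sK01; sZ1; sX2; sCX20; sCCX01; sK01];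
 [:: sK01; sZ1; sX2; sCX21; sCCX01; sK01];
 [:: sK01; sZ2; sCX02; sCCX12; sK12; sX0];
 [:: sK01; sZ2; sCX10; sCX21; sCCX01; sK01];
 [:: sK01; sZ2; sX0; sCCX01; sK01; sX0];
 [:: sK01; sZ2; sX0; sCX01; sCCX12; sK12];
 [:: sK01; sZ2; sX0; sCX02; sCCX12; sK12];
 [:: sK01; sZ2; sX1; sCCX01; sCX12; sK01];
 [:: sK01; sZ2; sX1; sCCX01; sK01; sX1];
 [:: sK01; sZ2; sX2; sCX21; sCCX01; sK01];
 [:: sK12; sCCX12; sCX02; sCZ01; sK01; sX2];
 [:: sK12; sCCX12; sCX02; sK01; sZ0; sX0];
 [:: sK12; sCCX12; sCX10; sCZ12; sK12; sX0];
 [:: sK12; sCCX12; sCX10; sK12; sZ1; sX1];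
 [:: sK12; sCCX12; sCX20; sCZ12; sK12; sX0];
 [:: sK12; sCCX12; sCX21; sK12; sZ1; sX1];
 [:: sK12; sCCX12; sCZ02; sCX10; sK12; sX0];
 [:: sK12; sCCX12; sCZ12; sCX01; sCX12; sK01];
 [:: sK12; sCCX12; sCZ12; sK12; sZ1; sX1];
 [:: sK12; sCCX12; sCZ12; sK12; sZ2; sX2];
 [:: sK12; sCCX12; sK12; sX2; sZ2; sX2];
 [:: sK12; sCCX12; sX2; sCZ12; sK12; sX2];
 [:: sK12; sCX01; sCCX01; sK01; sZ1; sX1];
 [:: sK12; sCX01; sCCX12; sK12; sZ1; sX1];
 [:: sK12; sCX01; sCCX12; sK12; sZ2; sX2];
 [:: sK12; sCX01; sCZ01; sCCX12; sK12; sX0];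
 [:: sK12; sCX01; sCZ02; sCCX12; sK12; sX0];
 [:: sK12; sCX01; sX1; sCCX12; sK12; sX1];
 [:: sK12; sCX01; sX2; sCCX12; sK12; sX2];
 [:: sK12; sCX01; sZ0; sCCX12; sCX02; sK01];
 [:: sK12; sCX01; sZ0; sCCX12; sK12; sX0];
 [:: sK12; sCX01; sZ0; sCX20; sCCX01; sK01];
 [:: sK12; sCX02; sCCX12; sK12; sZ1; sX1];
 [:: sK12; sCX02; sCCX12; sK12; sZ2; sX2];
 [:: sK12; sCX02; sCX01; sCCX12; sK12; sX0];
 [:: sK12; sCX02; sCZ01; sCCX12; sK12; sX0];
 [:: sK12; sCX02; sCZ02; sCCX12; sK12; sX0];
 [:: sK12; sCX02; sX2; sCCX12; sK12; sX2];
 [:: sK12; sCX10; sCCX02; sCZ01; sCX12; sK01];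
 [:: sK12; sCX10; sCCX02; sZ0; sCX12; sK01];
 [:: sK12; sCX10; sCX21; sCCX01; sK01; sX0];
 [:: sK12; sCX10; sCX21; sCCX01; sK01; sX1];
 [:: sK12; sCX10; sCX21; sCCX01; sK01; sX2];
 [:: sK12; sCX10; sX1; sCCX12; sK12; sX1];
 [:: sK12; sCX12; sCCX12; sK12; sZ2; sX2];
 [:: sK12; sCX12; sCX01; sCCX12; sK12; sX0];
 [:: sK12; sCX20; sCCX01; sCZ01; sCX12; sK01];
 [:: sK12; sCX20; sCCX01; sCZ01; sK01; sX2];
 [:: sK12; sCX20; sCCX01; sK01; sX2; sX0];
 [:: sK12; sCX20; sCCX01; sK01; sX2; sX1];
 [:: sK12; sCX20; sCCX01; sK01; sZ0; sX0];
 [:: sK12; sCX20; sCZ02; sCCX01; sK01; sX2];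
 [:: sK12; sCX20; sCZ12; sCCX01; sK01; sX2];
 [:: sK12; sCX20; sX0; sCCX01; sK01; sX0];
 [:: sK12; sCX20; sX2; sCCX12; sK12; sX2];
 [:: sK12; sCX21; sCCX01; sK01; sZ1; sX1];
 [:: sK12; sCX21; sCCX12; sK12; sZ1; sX1];
 [:: sK12; sCX21; sCX02; sCCX12; sK12; sX0];
 [:: sK12; sCX21; sCZ02; sCCX01; sK01; sX2];
 [:: sK12; sCX21; sCZ12; sCCX01; sK01; sX2];
 [:: sK12; sCX21; sX1; sCCX01; sK01; sX1];
 [:: sK12; sCX21; sZ0; sCX20; sCCX01; sK01];
 [:: sK12; sCZ01; sCX01; sCCX12; sK12; sX0];
 [:: sK12; sCZ01; sX0; sCX02; sCCX12; sK12];
 [:: sK12; sCZ02; sCX02; sCCX12; sK12; sX0];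
 [:: sK12; sCZ02; sX0; sCX01; sCCX12; sK12];
 [:: sK12; sCZ12; sX2; sCCX12; sCX02; sK01];
 [:: sK12; sCZ12; sX2; sCCX12; sK12; sX2];
 [:: sK12; sCZ12; sX2; sCX20; sCCX01; sK01];
 [:: sK12; sK01; sX2; sCX21; sCCX01; sK01];
 [:: sK12; sS01; sX0; sCX01; sCCX12; sK12];
 [:: sK12; sX0; sCX01; sCCX12; sCZ12; sK12];
 [:: sK12; sX0; sCX01; sCCX12; sK12; sX1];
 [:: sK12; sX0; sCX02; sCCX12; sCZ12; sK12];
 [:: sK12; sX0; sCX02; sCCX12; sK12; sX2];
 [:: sK12; sX0; sZ0; sCCX12; sK12; sX0];
 [:: sK12; sX0; sZ0; sCX20; sCCX01; sK01];
 [:: sK12; sX1; sCCX12; sCZ02; sCX10; sK12];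
 [:: sK12; sX1; sZ1; sCX01; sCCX12; sK12];
 [:: sK12; sX1; sZ1; sCX21; sCCX01; sK01];
 [:: sK12; sX2; sCCX12; sCZ01; sCX02; sK01];
 [:: sK12; sX2; sCX01; sCCX12; sK12; sX0];
 [:: sK12; sX2; sCX20; sCCX01; sCZ01; sK01];
 [:: sK12; sX2; sZ2; sCX02; sCCX12; sK12];
 [:: sK12; sZ0; sCX12; sCX01; sCCX12; sK12];
 [:: sK12; sZ0; sX0; sCX01; sCCX12; sK12];
 [:: sK12; sZ0; sX1; sCCX12; sK12; sX1];
 [:: sK12; sZ0; sX2; sCCX12; sK12; sX2];
 [:: sK12; sZ0; sX2; sCX21; sCCX01; sK01];
 [:: sK12; sZ1; sCX01; sCCX12; sCX02; sK01];
 [:: sK12; sZ1; sCX01; sCCX12; sK12; sX0];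
 [:: sK12; sZ1; sCX01; sCX20; sCCX01; sK01];
 [:: sK12; sZ1; sX0; sCX01; sCCX12; sK12];
 [:: sK12; sZ1; sX0; sCX02; sCCX12; sK12];
 [:: sK12; sZ1; sX1; sCCX12; sK12; sX1];
 [:: sK12; sZ2; sCX02; sCCX12; sK12; sX0];
 [:: sK12; sZ2; sCX12; sCX01; sCCX12; sK12];
 [:: sK12; sZ2; sX0; sCX01; sCCX12; sK12];
 [:: sK12; sZ2; sX0; sCX02; sCCX12; sK12];
 [:: sK12; sZ2; sX2; sCCX12; sK12; sX2];
 [:: sS01; sCX01; sCCX12; sCZ12; sK12; sX0];
 [:: sS01; sCX01; sCCX12; sK12; sX2; sX0];
 [:: sS01; sCX01; sCZ02; sCCX12; sK12; sX0];
 [:: sS01; sCX02; sCCX12; sK12; sX1; sX0];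
 [:: sS01; sCX02; sCZ01; sCCX12; sK12; sX0];
 [:: sS01; sCZ01; sX0; sCX02; sCCX12; sK12];
 [:: sS01; sCZ02; sX0; sCX01; sCCX12; sK12];
 [:: sS01; sCZ12; sK12; sX2; sZ2; sX2];
 [:: sS01; sK12; sCX10; sCX21; sCCX01; sK01];
 [:: sS01; sK12; sCX20; sCCX01; sCX12; sK01];
 [:: sS01; sK12; sCX20; sCCX01; sK01; sX2];
 [:: sS01; sX0; sZ0; sCCX12; sK12; sX0];
 [:: sS01; sZ1; sX0; sCX02; sCCX12; sK12];
 [:: sS01; sZ2; sX0; sCX01; sCCX12; sK12];
 [:: sS12; sCX20; sCCX01; sK01; sX2; sX0];
 [:: sS12; sCX20; sCZ02; sCCX01; sK01; sX2];
 [:: sS12; sCX21; sCZ12; sCCX01; sK01; sX2];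
 [:: sS12; sK12; sCX20; sCCX01; sK01; sX1];
 [:: sS12; sX0; sZ0; sCX20; sCCX01; sK01];
 [:: sS12; sX1; sZ1; sCX21; sCCX01; sK01];
 [:: sX0; sCX01; sCCX12; sK12; sZ1; sX1];
 [:: sX0; sCX01; sCCX12; sK12; sZ2; sX2];
 [:: sX0; sCX01; sCX12; sCCX12; sK12; sX2];
 [:: sX0; sCX02; sCCX12; sK12; sZ1; sX1];
 [:: sX0; sCX02; sCCX12; sK12; sZ2; sX2];
 [:: sX0; sCX02; sK01; sCX21; sCCX01; sK01];
 [:: sX0; sCX21; sCCX01; sK01; sX2; sX1];
 [:: sX0; sCX21; sCZ12; sCCX01; sK01; sX2];
 [:: sX0; sCX21; sX1; sCCX01; sK01; sX1];
 [:: sX0; sCX21; sZ2; sCCX01; sK01; sX2];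
 [:: sX0; sCZ02; sX2; sCX21; sCCX01; sK01];
 [:: sX0; sK01; sCX12; sCCX02; sCX10; sK12];
 [:: sX0; sK01; sCX12; sCX01; sCCX12; sK12];
 [:: sX0; sK12; sCCX12; sK12; sZ2; sX2];
 [:: sX0; sK12; sCX20; sCCX01; sK01; sX1];
 [:: sX0; sX1; sZ1; sCX21; sCCX01; sK01];
 [:: sX0; sZ0; sCX10; sCCX02; sCX12; sK01];
 [:: sX0; sZ0; sCX10; sCX21; sCCX01; sK01];
 [:: sX1; sCX01; sX2; sCCX12; sK12; sX2];
 [:: sX1; sCX02; sCZ01; sCCX12; sK12; sX0];
 [:: sX1; sCX10; sCX21; sCCX01; sK01; sX1];
 [:: sX1; sCX12; sCX01; sCCX12; sK12; sX1];
 [:: sX1; sCX20; sS01; sK12; sZ1; sX1];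
 [:: sX1; sCX21; sX0; sCCX01; sK01; sX0];
 [:: sX1; sCZ01; sX0; sCCX01; sK01; sX0];
 [:: sX1; sCZ02; sS01; sK12; sZ1; sX1];
 [:: sX1; sCZ12; sK12; sCCX12; sK12; sX0];
 [:: sX1; sK01; sCX12; sCCX02; sCX10; sK12];
 [:: sX1; sK01; sCX12; sCX01; sCCX12; sK12];
 [:: sX1; sK12; sCX10; sCCX02; sCX12; sK01];
 [:: sX1; sK12; sCX10; sCX21; sCCX01; sK01];
 [:: sX1; sS12; sX1; sCZ01; sK01; sX1];
 [:: sX1; sZ1; sCX01; sCX20; sCCX01; sK01];
 [:: sX2; sCCX02; sCX10; sCZ12; sK12; sX0];
 [:: sX2; sCCX02; sCX12; sK01; sZ2; sX2];
 [:: sX2; sCX01; sCZ02; sCCX12; sK12; sX0];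
 [:: sX2; sCX01; sX1; sCCX12; sK12; sX1];
 [:: sX2; sCX20; sCCX01; sK01; sZ0; sX0];
 [:: sX2; sCX20; sCCX01; sK01; sZ1; sX1];
 [:: sX2; sCX20; sK12; sCX01; sCCX12; sK12];
 [:: sX2; sCX21; sCCX01; sK01; sZ0; sX0];
 [:: sX2; sCX21; sCCX01; sK01; sZ1; sX1];
 [:: sX2; sCX21; sCX10; sCCX01; sK01; sX0];
 [:: sX2; sCZ01; sCX01; sCCX12; sK12; sX0];
 [:: sX2; sCZ02; sX0; sCX01; sCCX12; sK12];
 [:: sX2; sCZ12; sX1; sCCX12; sK12; sX1];
 [:: sX2; sK12; sCCX12; sK12; sX1; sX0];
 [:: sX2; sK12; sCX10; sCCX02; sCX12; sK01];
 [:: sX2; sK12; sCX10; sCX21; sCCX01; sK01];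
 [:: sX2; sK12; sCX20; sCCX01; sCX12; sK01];
 [:: sX2; sK12; sCX20; sCCX01; sK01; sX1];
 [:: sX2; sK12; sZ1; sCX01; sCCX12; sK12];
 [:: sX2; sX1; sZ1; sCX01; sCCX12; sK12];
 [:: sX2; sZ2; sCX12; sCCX02; sCX10; sK12];
 [:: sX2; sZ2; sCX12; sCX01; sCCX12; sK12];
 [:: sZ0; sCX01; sX2; sCCX12; sK12; sX2];
 [:: sZ0; sCX10; sX1; sCCX12; sK12; sX1];
 [:: sZ0; sCX12; sCX01; sCCX12; sK12; sX2];
 [:: sZ0; sCX20; sK12; sCX01; sCCX12; sK12];
 [:: sZ0; sCX20; sX0; sCCX01; sK01; sX0];
 [:: sZ0; sCX21; sCCX01; sK01; sZ2; sX2];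
 [:: sZ0; sCX21; sX0; sCCX01; sK01; sX0];
 [:: sZ0; sK12; sCX10; sCCX02; sCX12; sK01];
 [:: sZ0; sK12; sCX10; sCX21; sCCX01; sK01];
 [:: sZ0; sK12; sCX20; sCCX01; sK01; sX1];
 [:: sZ0; sX0; sCCX01; sCZ01; sCX02; sK01];
 [:: sZ0; sX0; sCCX02; sCZ02; sCX10; sK12];
 [:: sZ0; sX0; sCX01; sCCX12; sK12; sX1];
 [:: sZ0; sX0; sCX02; sCCX12; sK12; sX2];
 [:: sZ0; sZ1; sCX21; sCCX01; sK01; sX2];
 [:: sZ0; sZ1; sX2; sCCX12; sCX02; sK01];
 [:: sZ0; sZ1; sX2; sCX20; sCCX01; sK01];
 [:: sZ1; sCCX02; sCX10; sK12; sZ1; sX1];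
 [:: sZ1; sCCX02; sCX12; sK01; sZ1; sX1];
 [:: sZ1; sCX01; sCCX12; sCX10; sK12; sX2];
 [:: sZ1; sCX01; sX1; sCCX12; sK12; sX1];
 [:: sZ1; sCX21; sCCX01; sK01; sZ0; sX0];
 [:: sZ1; sCX21; sX0; sCCX01; sK01; sX0];
 [:: sZ1; sCX21; sX1; sCCX01; sK01; sX1];
 [:: sZ1; sX1; sCCX12; sCZ02; sCX10; sK12];
 [:: sZ1; sZ2; sX0; sCX01; sCCX12; sK12];
 [:: sZ2; sCX01; sCCX12; sK12; sZ0; sX0];
 [:: sZ2; sCX01; sCX20; sCCX01; sK01; sX1];
 [:: sZ2; sCX02; sCCX12; sK12; sZ1; sX1];
 [:: sZ2; sCX02; sX0; sCCX01; sK01; sX0];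
 [:: sZ2; sCX02; sX2; sCCX12; sK12; sX2];
 [:: sZ2; sCX10; sCX21; sCCX01; sK01; sX0];
 [:: sZ2; sCX21; sCX10; sCCX01; sK01; sX0];
 [:: sZ2; sCX21; sX0; sCCX01; sK01; sX0];
 [:: sZ2; sK01; sCX12; sCCX02; sCX10; sK12];
 [:: sZ2; sK01; sCX12; sCX01; sCCX12; sK12];
 [:: sZ2; sK12; sCX20; sCCX01; sK01; sX1];
 [:: sZ2; sK12; sZ1; sCX01; sCCX12; sK12];
 [:: sZ2; sX2; sCX20; sCCX01; sK01; sX0];
 [:: sZ2; sX2; sCX21; sCCX01; sK01; sX1];
 [:: sZ2; sZ1; sCX01; sCCX12; sK12; sX0];
 [:: sCCX01; sCX20; sCZ02; sCX10; sK12; sZ1; sX1];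
 [:: sCCX02; sCX01; sCZ01; sCX12; sK01; sZ1; sX1];
 [:: sCCX02; sCX10; sCZ01; sCX02; sK01; sZ0; sX0];
 [:: sCCX02; sCX20; sCZ02; sCX10; sK12; sZ1; sX1];
 [:: sCCX02; sCZ01; sCX01; sCX12; sK01; sZ2; sX2];
 [:: sCCX02; sX1; sCX20; sS01; sK12; sZ1; sX1];
 [:: sCCX12; sCX01; sCZ01; sCX12; sK01; sZ1; sX1];
 [:: sCX01; sCX02; sCZ12; sK01; sCCX01; sK01; sX1];
 [:: sCX01; sCX02; sK01; sCX21; sCCX01; sK01; sX2];
 [:: sCX01; sCX20; sCX12; sZ2; sCCX01; sK01; sX2];
 [:: sCX01; sCX20; sCZ01; sK01; sCCX01; sK01; sX2];
 [:: sCX01; sCX20; sK12; sCX01; sCCX12; sK12; sX0];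
 [:: sCX01; sCX20; sK12; sX0; sCX01; sCCX12; sK12];
 [:: sCX01; sCZ01; sCZ12; sK12; sCCX12; sK12; sX0];
 [:: sCX01; sCZ01; sK01; sCZ02; sCCX01; sK01; sX2];
 [:: sCX01; sCZ12; sK01; sCCX01; sCZ01; sK01; sX2];
 [:: sCX01; sCZ12; sK01; sCCX01; sK01; sX2; sX1];
 [:: sCX01; sCZ12; sK12; sCCX12; sK12; sX2; sX0];
 [:: sCX01; sCZ12; sK12; sCCX12; sK12; sZ2; sX2];
 [:: sCX01; sK01; sX2; sCX21; sCCX01; sK01; sX1];
 [:: sCX01; sK01; sZ0; sX2; sCX21; sCCX01; sK01];
 [:: sCX01; sK01; sZ1; sCX21; sCCX01; sK01; sX2];
 [:: sCX01; sX0; sCX02; sK01; sCX21; sCCX01; sK01];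
 [:: sCX01; sX2; sCX20; sK12; sCX01; sCCX12; sK12];
 [:: sCX01; sZ0; sCX20; sK12; sCX01; sCCX12; sK12];
 [:: sCX02; sCX01; sCCX12; sK12; sX2; sZ2; sX2];
 [:: sCX02; sCX01; sCZ12; sK12; sCCX12; sK12; sX0];
 [:: sCX02; sCX10; sCZ02; sK01; sCCX01; sK01; sX1];
 [:: sCX02; sCX10; sK12; sCX02; sCCX12; sK12; sX0];
 [:: sCX02; sCX10; sK12; sCX20; sCCX01; sK01; sX1];
 [:: sCX02; sCX21; sCZ01; sK01; sCCX01; sK01; sX2];
 [:: sCX02; sCZ01; sK01; sCCX01; sK01; sZ0; sX0];
 [:: sCX02; sCZ02; sCZ12; sK01; sCCX01; sK01; sX1];
 [:: sCX02; sCZ02; sCZ12; sK12; sCCX12; sK12; sX0];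
 [:: sCX02; sCZ12; sCX10; sK01; sCCX01; sK01; sX1];
 [:: sCX02; sCZ12; sCX12; sK01; sCCX01; sK01; sX1];
 [:: sCX02; sCZ12; sK01; sCCX01; sK01; sX2; sX1];
 [:: sCX02; sCZ12; sK12; sCCX12; sCX02; sK01; sX1];
 [:: sCX02; sCZ12; sK12; sCCX12; sK12; sX1; sX0];
 [:: sCX02; sCZ12; sK12; sCCX12; sK12; sZ2; sX2];
 [:: sCX02; sCZ12; sK12; sCX20; sCCX01; sK01; sX1];
 [:: sCX02; sCZ12; sK12; sCZ01; sCCX12; sK12; sX0];
 [:: sCX02; sCZ12; sK12; sX0; sCX02; sCCX12; sK12];
 [:: sCX02; sK01; sCX02; sCX01; sCCX12; sK12; sX0];
 [:: sCX02; sK01; sCX12; sCX01; sCCX12; sK12; sX0];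
 [:: sCX02; sK01; sCX12; sCX01; sCCX12; sK12; sX1];
 [:: sCX02; sK01; sCX12; sCX01; sCCX12; sK12; sX2];
 [:: sCX02; sK01; sCX21; sCCX01; sK01; sZ0; sX0];
 [:: sCX02; sK01; sCX21; sCCX01; sK01; sZ1; sX1];
 [:: sCX02; sK01; sCX21; sCZ12; sCCX01; sK01; sX2];
 [:: sCX02; sK01; sCX21; sZ2; sCX02; sCCX12; sK12];
 [:: sCX02; sK01; sCZ12; sCX21; sCCX01; sK01; sX2];
 [:: sCX02; sK01; sX2; sCX21; sCCX01; sK01; sX1];
 [:: sCX02; sK01; sZ0; sCX10; sCX21; sCCX01; sK01];
 [:: sCX02; sK01; sZ1; sCX01; sCX20; sCCX01; sK01];
 [:: sCX02; sK01; sZ1; sCX21; sCCX01; sCX02; sK01];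
 [:: sCX02; sK01; sZ1; sCX21; sCCX01; sK01; sX2];
 [:: sCX02; sK01; sZ1; sX2; sCX21; sCCX01; sK01];
 [:: sCX02; sK01; sZ2; sX2; sCX21; sCCX01; sK01];
 [:: sCX02; sK12; sX0; sCX01; sCCX12; sK12; sX1];
 [:: sCX02; sX1; sCZ12; sK12; sCCX12; sK12; sX0];
 [:: sCX02; sZ2; sK01; sCX12; sCCX02; sCX10; sK12];
 [:: sCX02; sZ2; sK01; sCX12; sCX01; sCCX12; sK12];
 [:: sCX02; sZ2; sK12; sCX20; sCCX01; sK01; sX1];
 [:: sCX10; sCCX02; sCZ01; sCX12; sK01; sZ2; sX2];
 [:: sCX10; sCX02; sCZ12; sK12; sCCX12; sK12; sX0];
 [:: sCX10; sCX12; sK01; sCX20; sCCX01; sK01; sX2];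
 [:: sCX10; sCX21; sCX02; sZ2; sCCX01; sK01; sX2];
 [:: sCX10; sCX21; sX2; sZ2; sCCX01; sK01; sX2];
 [:: sCX10; sK01; sCX02; sCZ02; sCCX12; sK12; sX0];
 [:: sCX10; sK12; sCX10; sCX21; sCCX01; sK01; sX0];
 [:: sCX10; sK12; sCX10; sCX21; sCCX01; sK01; sX1];
 [:: sCX10; sK12; sCX10; sCX21; sCCX01; sK01; sX2];
 [:: sCX10; sK12; sCX12; sCX01; sCCX12; sK12; sX0];
 [:: sCX10; sK12; sCX20; sCCX01; sK01; sX2; sX0];
 [:: sCX10; sK12; sCX20; sCCX01; sK01; sZ0; sX0];
 [:: sCX10; sK12; sCX20; sCZ02; sCCX01; sK01; sX2];
 [:: sCX10; sK12; sCX20; sX0; sCCX01; sK01; sX0];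
 [:: sCX10; sK12; sCX21; sCX02; sCCX12; sK12; sX0];
 [:: sCX10; sK12; sX0; sZ0; sCX20; sCCX01; sK01];
 [:: sCX10; sK12; sZ1; sCX01; sCX20; sCCX01; sK01];
 [:: sCX10; sK12; sZ2; sCX02; sCCX12; sK12; sX0];
 [:: sCX10; sX0; sCX02; sK01; sCX21; sCCX01; sK01];
 [:: sCX10; sZ0; sK12; sCX10; sCX21; sCCX01; sK01];
 [:: sCX10; sZ0; sK12; sCX20; sCCX01; sK01; sX1];
 [:: sCX10; sZ1; sCCX02; sCX12; sK01; sZ1; sX1];
 [:: sCX10; sZ1; sCX21; sX1; sCCX01; sK01; sX1];
 [:: sCX10; sZ2; sCX02; sX2; sCCX12; sK12; sX2];
 [:: sCX12; sCX01; sCCX12; sK12; sX2; sZ2; sX2];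
 [:: sCX12; sCX01; sCZ12; sK01; sCCX01; sK01; sX1];
 [:: sCX12; sCX01; sX0; sZ0; sCCX12; sK12; sX0];
 [:: sCX12; sCX20; sCZ01; sK01; sCCX01; sK01; sX2];
 [:: sCX12; sCZ02; sCZ12; sK01; sCCX01; sK01; sX1];
 [:: sCX12; sCZ02; sCZ12; sK12; sCCX12; sK12; sX0];
 [:: sCX12; sCZ12; sK12; sCX20; sCCX01; sK01; sX1];
 [:: sCX12; sCZ12; sK12; sCZ01; sCCX12; sK12; sX0];
 [:: sCX12; sK01; sCX02; sCCX12; sK12; sZ2; sX2];
 [:: sCX12; sK01; sCX02; sCZ02; sCCX12; sK12; sX0];
 [:: sCX12; sK01; sCX02; sX2; sCCX12; sK12; sX2];
 [:: sCX12; sK01; sCX12; sCX01; sCCX12; sK12; sX2];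
 [:: sCX12; sK01; sCX20; sCZ02; sCCX01; sK01; sX2];
 [:: sCX12; sK01; sX2; sZ2; sCX02; sCCX12; sK12];
 [:: sCX12; sK01; sZ0; sCX10; sCX21; sCCX01; sK01];
 [:: sCX12; sK01; sZ1; sCX01; sCX20; sCCX01; sK01];
 [:: sCX12; sK12; sCX20; sCCX01; sK01; sX2; sX0];
 [:: sCX12; sK12; sCX20; sCZ02; sCCX01; sK01; sX2];
 [:: sCX12; sK12; sX0; sCX01; sCCX12; sK12; sX1];
 [:: sCX12; sK12; sX0; sCX02; sCCX12; sCZ12; sK12];
 [:: sCX12; sK12; sX0; sCX02; sCCX12; sK12; sX2];
 [:: sCX12; sK12; sX0; sZ0; sCCX12; sK12; sX0];
 [:: sCX12; sK12; sZ1; sX0; sCX02; sCCX12; sK12];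
 [:: sCX12; sZ1; sCCX02; sCX10; sK12; sZ1; sX1];
 [:: sCX12; sZ2; sK01; sCX12; sCX01; sCCX12; sK12];
 [:: sCX12; sZ2; sK12; sCX20; sCCX01; sK01; sX1];
 [:: sCX20; sCX01; sCZ12; sK12; sCCX12; sK12; sX0];
 [:: sCX20; sCX12; sX2; sZ2; sCCX01; sK01; sX2];
 [:: sCX20; sCX21; sCZ01; sK01; sCCX01; sK01; sX1];
 [:: sCX20; sCZ01; sCX10; sK01; sCCX01; sK01; sX1];
 [:: sCX20; sCZ01; sCX12; sK01; sCCX01; sK01; sX1];
 [:: sCX20; sCZ01; sK01; sCCX01; sK01; sZ0; sX0];
 [:: sCX20; sCZ01; sK12; sCCX12; sK12; sX2; sX0];
 [:: sCX20; sCZ02; sK12; sZ1; sCX01; sCCX12; sK12];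
 [:: sCX20; sCZ12; sK12; sCCX12; sK12; sZ2; sX2];
 [:: sCX20; sK01; sZ0; sCX10; sCX21; sCCX01; sK01];
 [:: sCX20; sK01; sZ1; sCX21; sCCX01; sK01; sX2];
 [:: sCX20; sK12; sCX01; sCCX12; sK12; sZ1; sX1];
 [:: sCX20; sK12; sCX01; sCCX12; sK12; sZ2; sX2];
 [:: sCX20; sK12; sCX01; sX1; sCCX12; sK12; sX1];
 [:: sCX20; sK12; sCX01; sX2; sCCX12; sK12; sX2];
 [:: sCX20; sK12; sCX10; sCCX02; sCZ01; sCX12; sK01];
 [:: sCX20; sK12; sCX10; sCX21; sCCX01; sK01; sX0];
 [:: sCX20; sK12; sCX12; sCCX12; sK12; sZ2; sX2];
 [:: sCX20; sK12; sCZ01; sCX01; sCCX12; sK12; sX0];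
 [:: sCX20; sK12; sX1; sZ1; sCX01; sCCX12; sK12];
 [:: sCX20; sK12; sZ0; sX0; sCX01; sCCX12; sK12];
 [:: sCX20; sK12; sZ1; sCX01; sCCX12; sK12; sX0];
 [:: sCX20; sK12; sZ1; sX0; sCX01; sCCX12; sK12];
 [:: sCX20; sK12; sZ1; sX1; sCCX12; sK12; sX1];
 [:: sCX20; sK12; sZ2; sCX12; sCX01; sCCX12; sK12];
 [:: sCX20; sX0; sZ0; sCX10; sCCX02; sCX12; sK01];
 [:: sCX20; sX2; sCX01; sX1; sCCX12; sK12; sX1];
 [:: sCX20; sZ0; sCX21; sX0; sCCX01; sK01; sX0];
 [:: sCX20; sZ0; sK12; sCX10; sCX21; sCCX01; sK01];
 [:: sCX20; sZ1; sCX01; sX1; sCCX12; sK12; sX1];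
 [:: sCX20; sZ1; sCX21; sX0; sCCX01; sK01; sX0];
 [:: sCX21; sCX02; sCCX12; sCZ12; sK12; sZ1; sX1];
 [:: sCX21; sCX02; sCCX12; sK12; sX2; sZ2; sX2];
 [:: sCX21; sCX02; sCX10; sZ0; sCCX12; sK12; sX0];
 [:: sCX21; sCX02; sX0; sZ0; sCCX12; sK12; sX0];
 [:: sCX21; sCX02; sX2; sZ2; sCCX01; sK01; sX2];
 [:: sCX21; sCZ01; sK01; sCCX01; sK01; sX2; sX1];
 [:: sCX21; sCZ01; sK01; sCCX01; sK01; sZ0; sX0];
 [:: sCX21; sCZ01; sX0; sX1; sCCX01; sK01; sX1];
 [:: sCX21; sCZ12; sCX20; sCCX01; sK01; sX2; sX0];
 [:: sCX21; sK12; sX0; sCX01; sCCX12; sK12; sX1];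
 [:: sCX21; sK12; sX0; sCX02; sCCX12; sK12; sX2];
 [:: sCX21; sK12; sX0; sZ0; sCCX12; sK12; sX0];
 [:: sCX21; sK12; sZ1; sCX01; sCCX12; sK12; sX0];
 [:: sCX21; sK12; sZ2; sX0; sCX01; sCCX12; sK12];
 [:: sCZ01; sCX01; sCZ12; sK12; sCCX12; sK12; sX0];
 [:: sCZ01; sCX02; sK12; sCCX12; sK12; sX1; sX0];
 [:: sCZ01; sCX10; sCZ02; sK01; sCCX01; sK01; sX1];
 [:: sCZ01; sCX10; sK12; sCX20; sCCX01; sK01; sX1];
 [:: sCZ01; sCX12; sK12; sCCX12; sK12; sX1; sX0];
 [:: sCZ01; sCX20; sK12; sCCX12; sCX02; sK01; sX1];
 [:: sCZ01; sCX20; sK12; sCCX12; sK12; sX1; sX0];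
 [:: sCZ01; sCX20; sK12; sCCX12; sK12; sZ2; sX2];
 [:: sCZ01; sCX21; sK12; sCCX12; sCZ12; sK12; sX0];
 [:: sCZ01; sCX21; sK12; sCCX12; sK12; sX2; sX0];
 [:: sCZ01; sCZ12; sCX12; sK01; sCCX01; sK01; sX1];
 [:: sCZ01; sCZ12; sK01; sCCX01; sK01; sX2; sX1];
 [:: sCZ01; sCZ12; sK12; sCCX12; sCX02; sK01; sX1];
 [:: sCZ01; sCZ12; sK12; sCZ01; sCCX12; sK12; sX0];
 [:: sCZ01; sK01; sCCX01; sCX02; sK01; sZ0; sX0];
 [:: sCZ01; sK01; sCCX01; sCZ01; sK01; sZ0; sX0];
 [:: sCZ01; sK01; sCX02; sCCX12; sK12; sZ2; sX2];
 [:: sCZ01; sK01; sCX02; sX0; sCCX01; sK01; sX0];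
 [:: sCZ01; sK01; sCX02; sX2; sCCX12; sK12; sX2];
 [:: sCZ01; sK01; sCX12; sCCX02; sCZ02; sCX10; sK12];
 [:: sCZ01; sK01; sCX12; sCX01; sCCX12; sK12; sX1];
 [:: sCZ01; sK01; sCX21; sX0; sCCX01; sK01; sX0];
 [:: sCZ01; sK01; sCZ01; sX0; sCCX01; sK01; sX0];
 [:: sCZ01; sK01; sCZ12; sCX21; sCCX01; sK01; sX2];
 [:: sCZ01; sK01; sX2; sCX21; sCCX01; sK01; sX1];
 [:: sCZ01; sK01; sZ0; sCX10; sCX21; sCCX01; sK01];
 [:: sCZ01; sK01; sZ0; sX2; sCX21; sCCX01; sK01];
 [:: sCZ01; sK01; sZ1; sCX01; sCX20; sCCX01; sK01];
 [:: sCZ01; sK01; sZ1; sX2; sCX20; sCCX01; sK01];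
 [:: sCZ01; sK12; sCCX12; sK12; sX2; sZ2; sX2];
 [:: sCZ01; sK12; sCX20; sCCX01; sK01; sX2; sX0];
 [:: sCZ01; sK12; sCX20; sCZ02; sCCX01; sK01; sX2];
 [:: sCZ01; sK12; sX0; sZ0; sCCX12; sK12; sX0];
 [:: sCZ01; sK12; sZ1; sX0; sCX02; sCCX12; sK12];
 [:: sCZ01; sK12; sZ1; sX1; sCCX12; sK12; sX1];
 [:: sCZ01; sK12; sZ2; sX2; sCCX12; sK12; sX2];
 [:: sCZ01; sX0; sK01; sCX12; sCX01; sCCX12; sK12];
 [:: sCZ01; sX1; sCZ12; sK12; sCCX12; sK12; sX0];
 [:: sCZ01; sX1; sK01; sCX12; sCX01; sCCX12; sK12];
 [:: sCZ01; sZ2; sK01; sCX12; sCX01; sCCX12; sK12];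
 [:: sCZ01; sZ2; sK12; sCX20; sCCX01; sK01; sX1];
 [:: sCZ02; sCX02; sCZ12; sK12; sCCX12; sK12; sX0];
 [:: sCZ02; sCX02; sK12; sCCX12; sK12; sX1; sX0];
 [:: sCZ02; sCX20; sCZ01; sK01; sCCX01; sK01; sX2];
 [:: sCZ02; sCX21; sK12; sCCX12; sK12; sX2; sX0];
 [:: sCZ02; sCZ01; sK12; sCCX12; sK12; sX1; sX0];
 [:: sCZ02; sCZ12; sK01; sCCX01; sK01; sX2; sX1];
 [:: sCZ02; sCZ12; sK12; sCZ02; sCCX12; sK12; sX0];
 [:: sCZ02; sK01; sZ0; sCX10; sCX21; sCCX01; sK01];
 [:: sCZ02; sK01; sZ0; sX2; sCX21; sCCX01; sK01];
 [:: sCZ02; sK01; sZ1; sCX21; sCCX01; sK01; sX2];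
 [:: sCZ02; sK12; sCCX12; sK12; sX2; sZ2; sX2];
 [:: sCZ02; sK12; sX0; sZ0; sCCX12; sK12; sX0];
 [:: sCZ02; sK12; sZ1; sCX01; sCCX12; sK12; sX0];
 [:: sCZ02; sK12; sZ1; sX1; sCCX12; sK12; sX1];
 [:: sCZ02; sK12; sZ2; sX2; sCCX12; sK12; sX2];
 [:: sCZ02; sX0; sCX02; sK01; sCX21; sCCX01; sK01];
 [:: sCZ02; sX1; sCZ12; sK12; sCCX12; sK12; sX0];
 [:: sCZ02; sX2; sCX20; sK12; sCX01; sCCX12; sK12];
 [:: sCZ12; sCX02; sK01; sCCX01; sK01; sZ0; sX0];
 [:: sCZ12; sCX02; sK12; sCCX12; sK12; sX1; sX0];
 [:: sCZ12; sCX12; sCZ02; sK01; sCCX01; sK01; sX1];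
 [:: sCZ12; sCX12; sK12; sCCX12; sK12; sX1; sX0];
 [:: sCZ12; sCX12; sK12; sCX20; sCCX01; sK01; sX1];
 [:: sCZ12; sCX21; sCZ01; sK01; sCCX01; sK01; sX2];
 [:: sCZ12; sCX21; sK12; sCCX12; sK12; sX2; sX0];
 [:: sCZ12; sCZ01; sCX10; sK01; sCCX01; sK01; sX1];
 [:: sCZ12; sCZ01; sK01; sCCX01; sK01; sZ0; sX0];
 [:: sCZ12; sCZ01; sK12; sCCX12; sK12; sX1; sX0];
 [:: sCZ12; sCZ01; sK12; sCCX12; sK12; sX2; sX0];
 [:: sCZ12; sK01; sCX02; sCZ02; sCCX12; sK12; sX0];
 [:: sCZ12; sK12; sCCX12; sCX02; sK01; sZ0; sX0];
 [:: sCZ12; sK12; sCCX12; sK12; sX2; sZ2; sX2];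
 [:: sCZ12; sK12; sCX01; sCCX12; sK12; sZ1; sX1];
 [:: sCZ12; sK12; sCX01; sCCX12; sK12; sZ2; sX2];
 [:: sCZ12; sK12; sCX01; sX1; sCCX12; sK12; sX1];
 [:: sCZ12; sK12; sCX01; sX2; sCCX12; sK12; sX2];
 [:: sCZ12; sK12; sCX10; sCX21; sCCX01; sK01; sX1];
 [:: sCZ12; sK12; sCX20; sCCX01; sK01; sZ0; sX0];
 [:: sCZ12; sK12; sCX20; sX0; sCCX01; sK01; sX0];
 [:: sCZ12; sK12; sCX20; sX2; sCCX12; sK12; sX2];
 [:: sCZ12; sK12; sCZ01; sCX01; sCCX12; sK12; sX0];
 [:: sCZ12; sK12; sX0; sCX01; sCCX12; sK12; sX1];
 [:: sCZ12; sK12; sX0; sZ0; sCCX12; sK12; sX0];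
 [:: sCZ12; sK12; sZ1; sCX01; sCX20; sCCX01; sK01];
 [:: sCZ12; sK12; sZ1; sX1; sCCX12; sK12; sX1];
 [:: sCZ12; sK12; sZ2; sCX12; sCX01; sCCX12; sK12];
 [:: sCZ12; sK12; sZ2; sX2; sCCX12; sK12; sX2];
 [:: sK01; sCCX01; sCX10; sCX02; sK01; sZ0; sX0];
 [:: sK01; sCX01; sCX20; sCCX01; sK01; sZ0; sX0];
 [:: sK01; sCX01; sCX20; sCCX01; sK01; sZ1; sX1];
 [:: sK01; sCX01; sCX20; sCZ02; sCCX01; sK01; sX2];
 [:: sK01; sCX01; sCX21; sCCX01; sK01; sZ1; sX1];
 [:: sK01; sCX01; sCX21; sCCX12; sK12; sX1; sX0];
 [:: sK01; sCX01; sCX21; sCZ12; sCCX01; sK01; sX2];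
 [:: sK01; sCX01; sX0; sCX02; sCCX12; sCZ12; sK12];
 [:: sK01; sCX01; sX0; sCX02; sCCX12; sK12; sX2];
 [:: sK01; sCX01; sX0; sZ0; sCCX12; sK12; sX0];
 [:: sK01; sCX01; sX0; sZ0; sCX20; sCCX01; sK01];
 [:: sK01; sCX01; sX2; sZ2; sCX02; sCCX12; sK12];
 [:: sK01; sCX01; sZ0; sX2; sCX20; sCCX01; sK01];
 [:: sK01; sCX01; sZ2; sX0; sCX02; sCCX12; sK12];
 [:: sK01; sCX02; sCCX12; sCX10; sK12; sZ1; sX1];
 [:: sK01; sCX02; sCCX12; sCZ12; sK12; sZ1; sX1];
 [:: sK01; sCX02; sCCX12; sCZ12; sK12; sZ2; sX2];
 [:: sK01; sCX02; sCX01; sCCX12; sK12; sX1; sX0];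
 [:: sK01; sCX02; sCX01; sX2; sCCX12; sK12; sX2];
 [:: sK01; sCX02; sCX21; sCCX01; sK01; sZ1; sX1];
 [:: sK01; sCX02; sCZ12; sK12; sCCX12; sK12; sX0];
 [:: sK01; sCX02; sCZ12; sX2; sCCX12; sK12; sX2];
 [:: sK01; sCX02; sX0; sCX01; sCCX12; sK12; sX1];
 [:: sK01; sCX02; sX0; sZ0; sCCX12; sK12; sX0];
 [:: sK01; sCX02; sX2; sZ2; sCCX01; sK01; sX2];
 [:: sK01; sCX02; sZ2; sX0; sCCX01; sK01; sX0];
 [:: sK01; sCX02; sZ2; sX2; sCCX12; sK12; sX2];
 [:: sK01; sCX10; sCX20; sCCX01; sK01; sZ0; sX0];
 [:: sK01; sCX10; sCX20; sCZ02; sCCX01; sK01; sX2];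
 [:: sK01; sCX10; sCX21; sCCX01; sK01; sZ0; sX0];
 [:: sK01; sCX10; sCX21; sCCX01; sK01; sZ1; sX1];
 [:: sK01; sCX10; sCX21; sCZ02; sCCX01; sK01; sX2];
 [:: sK01; sCX10; sCX21; sCZ12; sCCX01; sK01; sX2];
 [:: sK01; sCX10; sCX21; sX0; sCCX01; sK01; sX0];
 [:: sK01; sCX10; sCX21; sZ2; sCCX01; sK01; sX2];
 [:: sK01; sCX10; sX0; sZ0; sCX20; sCCX01; sK01];
 [:: sK01; sCX10; sX1; sZ1; sCX21; sCCX01; sK01];
 [:: sK01; sCX10; sZ1; sX2; sCX21; sCCX01; sK01];
 [:: sK01; sCX10; sZ2; sX2; sCX21; sCCX01; sK01];
 [:: sK01; sCX12; sCCX02; sCX10; sCZ12; sK12; sX0];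
 [:: sK01; sCX12; sCCX02; sCX10; sK12; sZ0; sX0];
 [:: sK01; sCX12; sCCX02; sCX10; sK12; sZ1; sX1];
 [:: sK01; sCX12; sCX01; sCCX12; sK12; sZ0; sX0];
 [:: sK01; sCX12; sCX01; sCCX12; sK12; sZ1; sX1];
 [:: sK01; sCX12; sCX01; sCCX12; sK12; sZ2; sX2];
 [:: sK01; sCX12; sCX01; sCZ01; sCCX12; sK12; sX0];
 [:: sK01; sCX12; sCX01; sCZ02; sCCX12; sK12; sX0];
 [:: sK01; sCX12; sCX02; sCCX12; sK12; sZ2; sX2];
 [:: sK01; sCX12; sCX20; sCCX01; sK01; sZ0; sX0];
 [:: sK01; sCX12; sCZ01; sCX01; sCCX12; sK12; sX0];
 [:: sK01; sCX12; sX0; sCX02; sCCX12; sK12; sX2];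
 [:: sK01; sCX12; sZ2; sX0; sCX01; sCCX12; sK12];
 [:: sK01; sCX20; sCCX01; sCZ01; sK01; sZ0; sX0];
 [:: sK01; sCX20; sCX01; sCCX01; sK01; sZ1; sX1];
 [:: sK01; sCX20; sCX21; sCCX01; sK01; sZ0; sX0];
 [:: sK01; sCX20; sCX21; sCCX01; sK01; sZ1; sX1];
 [:: sK01; sCX20; sCX21; sCZ12; sCCX01; sK01; sX2];
 [:: sK01; sCX20; sCX21; sX0; sCCX01; sK01; sX0];
 [:: sK01; sCX20; sCX21; sZ2; sCCX01; sK01; sX2];
 [:: sK01; sCX20; sCZ01; sX0; sCCX01; sK01; sX0];
 [:: sK01; sCX20; sX0; sCX01; sCCX01; sK01; sX1];
 [:: sK01; sCX20; sX1; sCZ12; sCCX01; sK01; sX2];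
 [:: sK01; sCX21; sCCX01; sCX02; sK01; sZ0; sX0];
 [:: sK01; sCX21; sCCX01; sCX12; sK01; sZ1; sX1];
 [:: sK01; sCX21; sCCX01; sCZ01; sK01; sZ0; sX0];
 [:: sK01; sCX21; sCCX01; sCZ01; sK01; sZ1; sX1];
 [:: sK01; sCX21; sCCX01; sZ2; sCX12; sK01; sX2];
 [:: sK01; sCX21; sCX01; sCCX12; sK12; sZ1; sX1];
 [:: sK01; sCX21; sCX02; sCCX12; sK12; sZ1; sX1];
 [:: sK01; sCX21; sCX02; sCZ01; sCCX12; sK12; sX0];
 [:: sK01; sCX21; sCX10; sCCX01; sK01; sZ0; sX0];
 [:: sK01; sCX21; sCX12; sX1; sCCX01; sK01; sX1];
 [:: sK01; sCX21; sCX20; sCZ02; sCCX01; sK01; sX2];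
 [:: sK01; sCX21; sCZ01; sX1; sCCX01; sK01; sX1];
 [:: sK01; sCX21; sCZ02; sCX02; sCCX12; sK12; sX0];
 [:: sK01; sCX21; sX0; sCX01; sCCX01; sK01; sX1];
 [:: sK01; sCX21; sX0; sCZ02; sCCX01; sK01; sX2];
 [:: sK01; sCX21; sZ2; sX1; sCCX01; sCX12; sK01];
 [:: sK01; sCZ01; sCX02; sCX01; sCCX12; sK12; sX0];
 [:: sK01; sCZ01; sCX02; sX0; sCCX01; sK01; sX0];
 [:: sK01; sCZ01; sK12; sCCX12; sCX02; sK01; sX1];
 [:: sK01; sCZ01; sK12; sCX20; sCCX01; sK01; sX1];
 [:: sK01; sCZ02; sCX02; sCX01; sCCX12; sK12; sX0];
 [:: sK01; sCZ12; sCX02; sCX01; sCCX12; sK12; sX0];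
 [:: sK01; sK12; sCX01; sCZ02; sCCX12; sK12; sX0];
 [:: sK01; sK12; sX0; sCX01; sCCX12; sK12; sX1];
 [:: sK01; sK12; sZ1; sCX01; sCCX12; sCX02; sK01];
 [:: sK01; sK12; sZ1; sCX01; sCCX12; sK12; sX0];
 [:: sK01; sK12; sZ2; sX0; sCX01; sCCX12; sK12];
 [:: sK01; sS01; sCX02; sCZ01; sCCX12; sK12; sX0];
 [:: sK01; sS01; sCZ01; sX0; sCX02; sCCX12; sK12];
 [:: sK01; sS12; sX1; sZ1; sCX21; sCCX01; sK01];
 [:: sK01; sX0; sZ0; sCX10; sCX21; sCCX01; sK01];
 [:: sK01; sX1; sCX10; sCX21; sCCX01; sK01; sX1];
 [:: sK01; sX1; sCX12; sCX01; sCCX12; sK12; sX1];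
 [:: sK01; sX1; sCX21; sX0; sCCX01; sK01; sX0];
 [:: sK01; sX1; sZ1; sCX01; sCX20; sCCX01; sK01];
 [:: sK01; sX2; sCX21; sCX10; sCCX01; sK01; sX0];
 [:: sK01; sX2; sZ2; sCX12; sCCX02; sCX10; sK12];
 [:: sK01; sX2; sZ2; sCX12; sCX01; sCCX12; sK12];
 [:: sK01; sZ1; sCX01; sX1; sCCX12; sK12; sX1];
 [:: sK01; sZ1; sCX21; sCCX01; sK01; sZ0; sX0];
 [:: sK01; sZ1; sCX21; sX0; sCCX01; sK01; sX0];
 [:: sK01; sZ1; sCX21; sX1; sCCX01; sK01; sX1];
 [:: sK01; sZ2; sCX02; sCCX12; sK12; sZ1; sX1];
 [:: sK01; sZ2; sCX02; sX2; sCCX12; sK12; sX2];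
 [:: sK01; sZ2; sCX21; sX0; sCCX01; sK01; sX0];
 [:: sK12; sCCX12; sCX21; sCX10; sK12; sZ1; sX1];
 [:: sK12; sCX01; sCCX12; sCX02; sK01; sZ0; sX0];
 [:: sK12; sCX01; sCCX12; sCZ12; sK12; sZ1; sX1];
 [:: sK12; sCX01; sCCX12; sCZ12; sK12; sZ2; sX2];
 [:: sK12; sCX01; sCX02; sCZ02; sCCX12; sK12; sX0];
 [:: sK12; sCX01; sCX02; sZ0; sCCX12; sK12; sX0];
 [:: sK12; sCX01; sCX12; sCCX12; sK12; sZ2; sX2];
 [:: sK12; sCX01; sCX20; sCCX01; sK01; sX2; sX1];
 [:: sK12; sCX01; sCX20; sCCX01; sK01; sZ0; sX0];
 [:: sK12; sCX01; sCX20; sCCX01; sK01; sZ1; sX1];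
 [:: sK12; sCX01; sCX20; sX2; sCCX12; sK12; sX2];
 [:: sK12; sCX01; sCX21; sCCX01; sK01; sZ1; sX1];
 [:: sK12; sCX01; sCZ12; sX1; sCCX12; sK12; sX1];
 [:: sK12; sCX01; sCZ12; sX2; sCCX12; sK12; sX2];
 [:: sK12; sCX01; sX0; sZ0; sCX20; sCCX01; sK01];
 [:: sK12; sCX01; sX1; sCX12; sCCX12; sK12; sX2];
 [:: sK12; sCX01; sX2; sCCX12; sCZ01; sCX02; sK01];
 [:: sK12; sCX01; sX2; sCX20; sCCX01; sCZ01; sK01];
 [:: sK12; sCX01; sX2; sCX20; sCCX01; sK01; sX0];
 [:: sK12; sCX01; sX2; sZ2; sCX02; sCCX12; sK12];
 [:: sK12; sCX01; sZ0; sX2; sCX20; sCCX01; sK01];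
 [:: sK12; sCX01; sZ2; sX0; sCX02; sCCX12; sK12];
 [:: sK12; sCX02; sCCX12; sCX10; sK12; sZ1; sX1];
 [:: sK12; sCX02; sCCX12; sCZ12; sK12; sZ1; sX1];
 [:: sK12; sCX02; sCCX12; sCZ12; sK12; sZ2; sX2];
 [:: sK12; sCX02; sCX01; sX2; sCCX12; sK12; sX2];
 [:: sK12; sCX02; sCZ12; sX2; sCCX12; sK12; sX2];
 [:: sK12; sCX02; sX0; sZ0; sCX20; sCCX01; sK01];
 [:: sK12; sCX10; sCCX02; sCX12; sK01; sZ0; sX0];
 [:: sK12; sCX10; sCCX02; sCX12; sK01; sZ2; sX2];
 [:: sK12; sCX10; sCCX02; sS01; sK12; sZ1; sX1];
 [:: sK12; sCX10; sCX20; sCCX01; sK01; sZ0; sX0];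
 [:: sK12; sCX10; sCX20; sCZ02; sCCX01; sK01; sX2];
 [:: sK12; sCX10; sCX21; sCCX01; sK01; sZ0; sX0];
 [:: sK12; sCX10; sCX21; sCCX01; sK01; sZ1; sX1];
 [:: sK12; sCX10; sCX21; sCCX01; sK01; sZ2; sX2];
 [:: sK12; sCX10; sCX21; sCZ02; sCCX01; sK01; sX2];
 [:: sK12; sCX10; sCX21; sCZ12; sCCX01; sK01; sX2];
 [:: sK12; sCX10; sCX21; sX0; sCCX01; sK01; sX0];
 [:: sK12; sCX10; sCZ12; sCX21; sCCX01; sK01; sX2];
 [:: sK12; sCX10; sX0; sZ0; sCCX12; sK12; sX0];
 [:: sK12; sCX10; sX0; sZ0; sCX20; sCCX01; sK01];
 [:: sK12; sCX10; sX1; sZ1; sCX21; sCCX01; sK01];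
 [:: sK12; sCX10; sX2; sCX21; sCCX01; sK01; sX1];
 [:: sK12; sCX10; sZ1; sX2; sCX21; sCCX01; sK01];
 [:: sK12; sCX12; sCX01; sCCX12; sK12; sZ1; sX1];
 [:: sK12; sCX12; sCX01; sCCX12; sK12; sZ2; sX2];
 [:: sK12; sCX12; sCX01; sCZ01; sCCX12; sK12; sX0];
 [:: sK12; sCX12; sCX01; sCZ02; sCCX12; sK12; sX0];
 [:: sK12; sCX12; sCX01; sZ0; sCCX12; sK12; sX0];
 [:: sK12; sCX12; sCX02; sCCX12; sK12; sZ2; sX2];
 [:: sK12; sCX12; sCX20; sCCX01; sK01; sZ0; sX0];
 [:: sK12; sCX20; sCCX01; sCZ01; sK01; sZ0; sX0];
 [:: sK12; sCX20; sCX01; sCCX01; sK01; sZ1; sX1];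
 [:: sK12; sCX20; sCX01; sCCX12; sK12; sZ1; sX1];
 [:: sK12; sCX20; sCX21; sCCX01; sK01; sX2; sX1];
 [:: sK12; sCX20; sCX21; sCCX01; sK01; sZ0; sX0];
 [:: sK12; sCX20; sCX21; sCCX01; sK01; sZ1; sX1];
 [:: sK12; sCX20; sCX21; sCZ12; sCCX01; sK01; sX2];
 [:: sK12; sCX20; sCX21; sX0; sCCX01; sK01; sX0];
 [:: sK12; sCX20; sCZ01; sX0; sCCX01; sK01; sX0];
 [:: sK12; sCX20; sX0; sZ0; sCCX12; sK12; sX0];
 [:: sK12; sCX21; sCX01; sCCX12; sK12; sZ1; sX1];
 [:: sK12; sCX21; sCX01; sCZ01; sCCX12; sK12; sX0];
 [:: sK12; sCX21; sCX02; sCCX12; sK12; sZ1; sX1];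
 [:: sK12; sCX21; sCX02; sCZ01; sCCX12; sK12; sX0];
 [:: sK12; sCX21; sCX02; sCZ02; sCCX12; sK12; sX0];
 [:: sK12; sCX21; sCX02; sZ0; sCCX12; sK12; sX0];
 [:: sK12; sCX21; sCZ02; sCX02; sCCX12; sK12; sX0];
 [:: sK12; sCX21; sX1; sZ1; sCX01; sCCX12; sK12];
 [:: sK12; sCZ01; sCX02; sCX01; sCCX12; sK12; sX0];
 [:: sK12; sCZ02; sCX02; sCX01; sCCX12; sK12; sX0];
 [:: sK12; sCZ12; sCX02; sCX01; sCCX12; sK12; sX0];
 [:: sK12; sCZ12; sCX10; sX1; sCCX12; sK12; sX1];
 [:: sK12; sCZ12; sK12; sCCX12; sCX02; sK01; sX1];
 [:: sK12; sCZ12; sK12; sCX20; sCCX01; sK01; sX1];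
 [:: sK12; sK01; sX2; sCX21; sCCX01; sK01; sX1];
 [:: sK12; sK01; sZ1; sCX01; sCX20; sCCX01; sK01];
 [:: sK12; sK01; sZ1; sCX21; sCCX01; sCX02; sK01];
 [:: sK12; sK01; sZ1; sCX21; sCCX01; sK01; sX2];
 [:: sK12; sK01; sZ1; sX0; sCX01; sCCX12; sK12];
 [:: sK12; sS01; sCX01; sCZ02; sCCX12; sK12; sX0];
 [:: sK12; sS01; sCZ02; sX0; sCX01; sCCX12; sK12];
 [:: sK12; sS12; sX0; sZ0; sCX20; sCCX01; sK01];
 [:: sK12; sX0; sCX01; sCX12; sCCX12; sK12; sX2];
 [:: sK12; sX0; sZ0; sCX10; sCCX02; sCX12; sK01];
 [:: sK12; sX0; sZ0; sCX10; sCX21; sCCX01; sK01];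
 [:: sK12; sX1; sCX01; sX2; sCCX12; sK12; sX2];
 [:: sK12; sX1; sCX10; sCX21; sCCX01; sK01; sX1];
 [:: sK12; sX1; sCX12; sCX01; sCCX12; sK12; sX1];
 [:: sK12; sX1; sCZ12; sK12; sCCX12; sK12; sX0];
 [:: sK12; sX1; sZ1; sCX01; sCX20; sCCX01; sK01];
 [:: sK12; sX2; sCX01; sCZ02; sCCX12; sK12; sX0];
 [:: sK12; sX2; sCZ01; sCX01; sCCX12; sK12; sX0];
 [:: sK12; sX2; sZ2; sCX12; sCX01; sCCX12; sK12];
 [:: sK12; sZ0; sCX01; sX2; sCCX12; sK12; sX2];
 [:: sK12; sZ0; sCX10; sX1; sCCX12; sK12; sX1];
 [:: sK12; sZ1; sCX01; sX1; sCCX12; sK12; sX1];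
 [:: sK12; sZ1; sX1; sCCX12; sCZ02; sCX10; sK12];
 [:: sK12; sZ2; sCX02; sCCX12; sK12; sZ1; sX1];
 [:: sK12; sZ2; sCX02; sX2; sCCX12; sK12; sX2];
 [:: sK12; sZ2; sX2; sCX20; sCCX01; sK01; sX0];
 [:: sS01; sCX01; sX0; sZ0; sCCX12; sK12; sX0];
 [:: sS01; sCX02; sX0; sZ0; sCCX12; sK12; sX0];
 [:: sS01; sCX02; sZ2; sX2; sCCX12; sK12; sX2];
 [:: sS01; sK01; sCX02; sCZ02; sCCX12; sK12; sX0];
 [:: sS01; sK12; sCX20; sCCX01; sK01; sX2; sX0];
 [:: sS01; sK12; sCX20; sCCX01; sK01; sZ0; sX0];
 [:: sS01; sK12; sCX20; sCZ02; sCCX01; sK01; sX2];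
 [:: sS01; sK12; sCX20; sX0; sCCX01; sK01; sX0];
 [:: sS01; sK12; sX0; sZ0; sCX20; sCCX01; sK01];
 [:: sS01; sZ2; sCX02; sX2; sCCX12; sK12; sX2];
 [:: sS12; sK01; sCX12; sCX01; sCCX12; sK12; sX1];
 [:: sS12; sZ2; sK12; sCX20; sCCX01; sK01; sX1];
 [:: sX0; sCX01; sCX20; sCCX01; sK01; sZ0; sX0];
 [:: sX0; sCX01; sCX21; sCCX01; sK01; sZ1; sX1];
 [:: sX0; sCX02; sCX21; sCCX01; sK01; sX2; sX1];
 [:: sX0; sCZ01; sK12; sCX20; sCCX01; sK01; sX1];
 [:: sX0; sCZ02; sCX21; sCCX01; sK01; sZ2; sX2];
 [:: sX0; sCZ12; sK01; sCCX01; sK01; sX2; sX1];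
 [:: sX0; sCZ12; sK12; sCCX12; sK12; sZ2; sX2];
 [:: sX0; sCZ12; sK12; sCX20; sCCX01; sK01; sX1];
 [:: sX0; sK01; sCX12; sCCX02; sCX10; sK12; sX2];
 [:: sX0; sK01; sCX12; sCX01; sCCX12; sK12; sX2];
 [:: sX0; sK01; sX2; sCX21; sCCX01; sK01; sX1];
 [:: sX0; sK01; sZ1; sCX21; sCCX01; sK01; sX2];
 [:: sX0; sK12; sCX01; sCCX12; sK12; sZ2; sX2];
 [:: sX0; sK12; sCX12; sCCX12; sK12; sZ2; sX2];
 [:: sX0; sK12; sCX21; sCCX12; sK12; sZ1; sX1];
 [:: sX0; sK12; sCZ12; sX2; sCCX12; sK12; sX2];
 [:: sX0; sX1; sZ1; sCX01; sCX20; sCCX01; sK01];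
 [:: sX0; sZ1; sCX21; sX1; sCCX01; sK01; sX1];
 [:: sX0; sZ2; sK01; sCX12; sCCX02; sCX10; sK12];
 [:: sX0; sZ2; sK01; sCX12; sCX01; sCCX12; sK12];
 [:: sX1; sCX02; sK01; sCCX01; sK01; sZ0; sX0];
 [:: sX1; sCZ01; sCZ12; sK12; sCCX12; sK12; sX0];
 [:: sX1; sCZ01; sK01; sCX21; sCCX01; sCX02; sK01];
 [:: sX1; sCZ01; sK01; sCX21; sCCX01; sK01; sX2];
 [:: sX1; sCZ01; sK01; sCZ02; sCCX01; sK01; sX2];
 [:: sX1; sCZ02; sK12; sCCX12; sK12; sX2; sX0];
 [:: sX1; sCZ12; sK12; sCCX12; sCZ12; sK12; sX0];
 [:: sX1; sCZ12; sK12; sCZ02; sCCX12; sK12; sX0];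
 [:: sX1; sCZ12; sK12; sX0; sCX01; sCCX12; sK12];
 [:: sX1; sK01; sCX02; sCZ02; sCCX12; sK12; sX0];
 [:: sX1; sK12; sCX20; sCCX01; sK01; sX2; sX0];
 [:: sX1; sK12; sCX20; sCZ02; sCCX01; sK01; sX2];
 [:: sX1; sK12; sX0; sCX02; sCCX12; sK12; sX2];
 [:: sX1; sK12; sZ2; sCX02; sCCX12; sK12; sX0];
 [:: sX1; sS12; sK12; sCX20; sCCX01; sK01; sX1];
 [:: sX1; sX0; sCX02; sK01; sCX21; sCCX01; sK01];
 [:: sX1; sX0; sZ0; sCX10; sCCX02; sCX12; sK01];
 [:: sX1; sZ1; sCX21; sX0; sCCX01; sK01; sX0];
 [:: sX2; sCX01; sCX20; sCCX01; sK01; sZ0; sX0];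
 [:: sX2; sCX01; sCZ12; sX1; sCCX12; sK12; sX1];
 [:: sX2; sCX21; sCX01; sCCX12; sK12; sZ1; sX1];
 [:: sX2; sCZ01; sK01; sCCX01; sK01; sZ0; sX0];
 [:: sX2; sCZ01; sK12; sCCX12; sK12; sX1; sX0];
 [:: sX2; sCZ01; sK12; sCX20; sCCX01; sK01; sX1];
 [:: sX2; sCZ12; sK12; sCX20; sCCX01; sK01; sX1];
 [:: sX2; sK01; sCX21; sCCX01; sK01; sZ0; sX0];
 [:: sX2; sK12; sCX10; sCX21; sCCX01; sK01; sX0];
 [:: sX2; sK12; sX0; sCX01; sCCX12; sK12; sX1];
 [:: sX2; sK12; sZ1; sCX01; sCCX12; sK12; sX0];
 [:: sX2; sK12; sZ1; sX0; sCX02; sCCX12; sK12];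
 [:: sX2; sX1; sCZ12; sK12; sCCX12; sK12; sX0];
 [:: sZ0; sCX10; sCX21; sCCX01; sK01; sZ2; sX2];
 [:: sZ0; sCX10; sK12; sCX10; sCX21; sCCX01; sK01];
 [:: sZ0; sCX12; sCX01; sCCX12; sK12; sZ1; sX1];
 [:: sZ0; sCX12; sCX20; sK12; sCX01; sCCX12; sK12];
 [:: sZ0; sCX20; sK12; sCCX12; sCX02; sK01; sX1];
 [:: sZ0; sCX20; sK12; sCCX12; sK12; sZ2; sX2];
 [:: sZ0; sCX20; sK12; sCX01; sCCX12; sK12; sX0];
 [:: sZ0; sCX20; sK12; sX0; sCX01; sCCX12; sK12];
 [:: sZ0; sCZ12; sK12; sCX20; sCCX01; sK01; sX1];
 [:: sZ0; sK01; sCX01; sCCX01; sK01; sZ1; sX1];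
 [:: sZ0; sK01; sZ1; sCX01; sCX20; sCCX01; sK01];
 [:: sZ0; sK12; sX0; sCX01; sCCX12; sK12; sX1];
 [:: sZ0; sK12; sX0; sCX02; sCCX12; sK12; sX2];
 [:: sZ0; sX0; sCX02; sK01; sCX21; sCCX01; sK01];
 [:: sZ0; sX2; sCX20; sK12; sCX01; sCCX12; sK12];
 [:: sZ1; sCX01; sCX20; sCCX01; sK01; sZ2; sX2];
 [:: sZ1; sK01; sZ1; sCX21; sCCX01; sK01; sX2];
 [:: sZ1; sK12; sCX12; sCCX12; sK12; sZ2; sX2];
 [:: sZ2; sCX02; sCX01; sCCX12; sK12; sX1; sX0];
 [:: sZ2; sCX02; sCZ12; sK12; sCCX12; sK12; sX0];
 [:: sZ2; sCX02; sK01; sCX21; sCCX01; sK01; sX2];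
 [:: sZ2; sCX10; sCX21; sX0; sCCX01; sK01; sX0];
 [:: sZ2; sCX12; sCCX02; sCX10; sK12; sZ1; sX1];
 [:: sZ2; sCX12; sCX01; sCCX12; sK12; sZ0; sX0];
 [:: sZ2; sCX12; sCX01; sCCX12; sK12; sZ1; sX1];
 [:: sZ2; sK12; sCZ02; sX0; sCX01; sCCX12; sK12];
 [:: sZ2; sK12; sZ1; sCX01; sCCX12; sCX02; sK01];
 [:: sZ2; sK12; sZ1; sCX01; sCX20; sCCX01; sK01];
 [:: sZ2; sX0; sCX02; sK01; sCX21; sCCX01; sK01];
 [:: sZ2; sX2; sCX20; sK12; sCX01; sCCX12; sK12];
 [:: sCX01; sCX02; sK01; sCX21; sCCX01; sK01; sZ0; sX0];
 [:: sCX01; sCZ12; sK12; sCCX12; sK12; sX2; sZ2; sX2];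
 [:: sCX01; sK12; sCX10; sCX21; sCCX01; sK01; sZ2; sX2];
 [:: sCX01; sX1; sCZ01; sK01; sCX21; sCCX01; sK01; sX2];
 [:: sCX01; sX1; sCZ01; sK01; sCZ02; sCCX01; sK01; sX2];
 [:: sCX01; sZ2; sX2; sCX20; sK12; sCX01; sCCX12; sK12];
 [:: sCX02; sCZ02; sX1; sCZ12; sK12; sCCX12; sK12; sX0];
 [:: sCX02; sCZ12; sK12; sCCX12; sK12; sX2; sZ2; sX2];
 [:: sCX02; sCZ12; sK12; sCX20; sX2; sCCX12; sK12; sX2];
 [:: sCX02; sK01; sCX12; sCX01; sCCX12; sK12; sZ2; sX2];
 [:: sCX02; sK01; sX1; sZ1; sCX01; sCX20; sCCX01; sK01];
 [:: sCX10; sCX12; sK01; sCX02; sCCX12; sK12; sZ2; sX2];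
 [:: sCX10; sCZ02; sK12; sCCX12; sK12; sX2; sZ2; sX2];
 [:: sCX10; sCZ02; sK12; sZ2; sX2; sCCX12; sK12; sX2];
 [:: sCX10; sK12; sCX02; sCX01; sX2; sCCX12; sK12; sX2];
 [:: sCX10; sK12; sCX02; sCZ12; sX2; sCCX12; sK12; sX2];
 [:: sCX10; sK12; sCX12; sCX01; sCCX12; sK12; sZ1; sX1];
 [:: sCX10; sK12; sCX12; sCX01; sCCX12; sK12; sZ2; sX2];
 [:: sCX10; sK12; sCX20; sCX21; sCCX01; sK01; sZ0; sX0];
 [:: sCX10; sK12; sCX20; sCX21; sCCX01; sK01; sZ1; sX1];
 [:: sCX10; sK12; sCX20; sCX21; sX0; sCCX01; sK01; sX0];
 [:: sCX10; sK12; sCX21; sCX02; sCCX12; sK12; sZ1; sX1];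
 [:: sCX10; sK12; sX0; sCX01; sCX12; sCCX12; sK12; sX2];
 [:: sCX10; sK12; sX0; sZ0; sCX10; sCX21; sCCX01; sK01];
 [:: sCX10; sK12; sX1; sZ1; sCX01; sCX20; sCCX01; sK01];
 [:: sCX10; sK12; sZ2; sCX02; sX2; sCCX12; sK12; sX2];
 [:: sCX10; sX1; sK01; sCX02; sCZ02; sCCX12; sK12; sX0];
 [:: sCX10; sZ2; sX0; sCX02; sK01; sCX21; sCCX01; sK01];
 [:: sCX12; sCZ02; sK12; sCCX12; sK12; sX2; sZ2; sX2];
 [:: sCX12; sCZ02; sK12; sX0; sZ0; sCCX12; sK12; sX0];
 [:: sCX12; sK01; sCX02; sCX01; sX2; sCCX12; sK12; sX2];
 [:: sCX12; sK01; sX2; sZ2; sCX12; sCX01; sCCX12; sK12];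
 [:: sCX12; sX1; sK12; sCX20; sCZ02; sCCX01; sK01; sX2];
 [:: sCX20; sCX12; sK12; sX0; sCX02; sCCX12; sK12; sX2];
 [:: sCX20; sCZ01; sK12; sCCX12; sK12; sX2; sZ2; sX2];
 [:: sCX20; sCZ01; sK12; sZ1; sX1; sCCX12; sK12; sX1];
 [:: sCX20; sK01; sCX12; sCX01; sCCX12; sK12; sZ0; sX0];
 [:: sCX20; sK12; sCX01; sCCX12; sCX02; sK01; sZ0; sX0];
 [:: sCX20; sK12; sCX01; sCX12; sCCX12; sK12; sZ2; sX2];
 [:: sCX20; sK12; sCX01; sCX20; sCCX01; sK01; sZ0; sX0];
 [:: sCX20; sK12; sCX01; sCX20; sCCX01; sK01; sZ1; sX1];
 [:: sCX20; sK12; sCX01; sCZ12; sX1; sCCX12; sK12; sX1];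
 [:: sCX20; sK12; sCX01; sX2; sCX20; sCCX01; sK01; sX0];
 [:: sCX20; sK12; sCX10; sCX21; sCCX01; sK01; sZ0; sX0];
 [:: sCX20; sK12; sCX10; sCX21; sX0; sCCX01; sK01; sX0];
 [:: sCX20; sK12; sCX20; sCX21; sCCX01; sK01; sZ0; sX0];
 [:: sCX20; sK12; sX0; sZ0; sCX10; sCX21; sCCX01; sK01];
 [:: sCX20; sK12; sX2; sZ2; sCX12; sCX01; sCCX12; sK12];
 [:: sCX20; sK12; sZ1; sCX01; sX1; sCCX12; sK12; sX1];
 [:: sCX21; sCX02; sCZ12; sK12; sCCX12; sK12; sZ2; sX2];
 [:: sCX21; sCZ01; sK01; sCX02; sX0; sCCX01; sK01; sX0];
 [:: sCX21; sCZ01; sK01; sCX21; sX0; sCCX01; sK01; sX0];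
 [:: sCX21; sCZ01; sK12; sCCX12; sK12; sX2; sZ2; sX2];
 [:: sCX21; sCZ01; sK12; sX0; sZ0; sCCX12; sK12; sX0];
 [:: sCX21; sK01; sCX12; sCCX02; sCX10; sK12; sZ0; sX0];
 [:: sCX21; sX1; sCZ01; sCZ12; sK12; sCCX12; sK12; sX0];
 [:: sCX21; sZ2; sX2; sCX20; sK12; sCX01; sCCX12; sK12];
 [:: sCZ01; sCZ02; sK12; sCCX12; sK12; sX2; sZ2; sX2];
 [:: sCZ01; sCZ12; sCX12; sK12; sCCX12; sK12; sX1; sX0];
 [:: sCZ01; sCZ12; sK12; sCCX12; sK12; sX2; sZ2; sX2];
 [:: sCZ01; sK01; sCX02; sCZ12; sX2; sCCX12; sK12; sX2];
 [:: sCZ01; sK01; sCX12; sCX01; sCCX12; sK12; sZ1; sX1];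
 [:: sCZ01; sK01; sCZ01; sCX02; sX0; sCCX01; sK01; sX0];
 [:: sCZ01; sK01; sX0; sZ0; sCX10; sCX21; sCCX01; sK01];
 [:: sCZ01; sK01; sX1; sZ1; sCX01; sCX20; sCCX01; sK01];
 [:: sCZ01; sK01; sX2; sZ2; sCX12; sCX01; sCCX12; sK12];
 [:: sCZ02; sCZ12; sK12; sCCX12; sK12; sX2; sZ2; sX2];
 [:: sCZ02; sX1; sCZ01; sK01; sCZ02; sCCX01; sK01; sX2];
 [:: sCZ02; sZ0; sX0; sCX02; sK01; sCX21; sCCX01; sK01];
 [:: sCZ02; sZ2; sX2; sCX20; sK12; sCX01; sCCX12; sK12];
 [:: sCZ12; sK12; sCX02; sX0; sZ0; sCX20; sCCX01; sK01];
 [:: sCZ12; sK12; sCX10; sCX20; sCCX01; sK01; sZ0; sX0];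
 [:: sCZ12; sK12; sCX10; sCX21; sCCX01; sK01; sZ1; sX1];
 [:: sCZ12; sK12; sCX20; sCZ01; sX0; sCCX01; sK01; sX0];
 [:: sCZ12; sK12; sX0; sCX01; sCX12; sCCX12; sK12; sX2];
 [:: sCZ12; sK12; sX0; sZ0; sCX10; sCX21; sCCX01; sK01];
 [:: sCZ12; sK12; sX1; sZ1; sCX01; sCX20; sCCX01; sK01];
 [:: sCZ12; sK12; sX2; sZ2; sCX12; sCX01; sCCX12; sK12];
 [:: sCZ12; sK12; sZ0; sCX10; sX1; sCCX12; sK12; sX1];
 [:: sK01; sCCX01; sCX20; sCZ02; sCX10; sK12; sZ1; sX1];
 [:: sK01; sCX02; sCZ12; sK12; sCX20; sCCX01; sK01; sX1];
 [:: sK01; sCX02; sK01; sZ1; sCX01; sCX20; sCCX01; sK01];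
 [:: sK01; sCX10; sZ2; sCX02; sX2; sCCX12; sK12; sX2];
 [:: sK01; sCX12; sCX01; sCCX12; sK12; sX2; sZ2; sX2];
 [:: sK01; sCX12; sCX01; sX0; sZ0; sCCX12; sK12; sX0];
 [:: sK01; sCX12; sK12; sX0; sCX02; sCCX12; sK12; sX2];
 [:: sK01; sCX12; sZ1; sCCX02; sCX10; sK12; sZ1; sX1];
 [:: sK01; sCX20; sZ1; sCX21; sX0; sCCX01; sK01; sX0];
 [:: sK01; sCX21; sCX02; sCCX12; sCZ12; sK12; sZ1; sX1];
 [:: sK01; sCX21; sCX02; sX0; sZ0; sCCX12; sK12; sX0];
 [:: sK01; sCZ01; sK12; sX0; sZ0; sCCX12; sK12; sX0];
 [:: sK01; sCZ01; sK12; sZ1; sX1; sCCX12; sK12; sX1];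
 [:: sK01; sK12; sCX01; sCX20; sCCX01; sK01; sZ0; sX0];
 [:: sK01; sK12; sZ1; sCX01; sX1; sCCX12; sK12; sX1];
 [:: sK01; sX0; sX1; sZ1; sCX01; sCX20; sCCX01; sK01];
 [:: sK01; sZ0; sCX12; sCX01; sCCX12; sK12; sZ1; sX1];
 [:: sK01; sZ2; sCX10; sCX21; sX0; sCCX01; sK01; sX0];
 [:: sK01; sZ2; sCX12; sCCX02; sCX10; sK12; sZ1; sX1];
 [:: sK01; sZ2; sCX12; sCX01; sCCX12; sK12; sZ1; sX1];
 [:: sK12; sCX02; sCZ12; sK12; sCX20; sCCX01; sK01; sX1];
 [:: sK12; sCX10; sCX21; sX2; sZ2; sCCX01; sK01; sX2];
 [:: sK12; sCX10; sZ1; sCCX02; sCX12; sK01; sZ1; sX1];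
 [:: sK12; sCX10; sZ1; sCX21; sX1; sCCX01; sK01; sX1];
 [:: sK12; sCX20; sX0; sZ0; sCX10; sCCX02; sCX12; sK01];
 [:: sK12; sCX20; sZ0; sCX21; sX0; sCCX01; sK01; sX0];
 [:: sK12; sCX20; sZ1; sCX21; sX0; sCCX01; sK01; sX0];
 [:: sK12; sCX21; sCX02; sCCX12; sCZ12; sK12; sZ1; sX1];
 [:: sK12; sCZ12; sCX21; sK12; sCCX12; sK12; sX2; sX0];
 [:: sK12; sK01; sZ1; sCX21; sX1; sCCX01; sK01; sX1];
 [:: sK12; sX0; sX1; sZ1; sCX01; sCX20; sCCX01; sK01];
 [:: sK12; sZ0; sCX12; sCX01; sCCX12; sK12; sZ1; sX1];
 [:: sK12; sZ2; sCX10; sCX21; sX0; sCCX01; sK01; sX0];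
 [:: sK12; sZ2; sCX12; sCX01; sCCX12; sK12; sZ1; sX1];
 [:: sS01; sK12; sX0; sZ0; sCX10; sCX21; sCCX01; sK01];
 [:: sS01; sX1; sK01; sCX02; sCZ02; sCCX12; sK12; sX0];
 [:: sS12; sCX02; sZ2; sK12; sCX20; sCCX01; sK01; sX1];
 [:: sS12; sK01; sCX12; sCX01; sCCX12; sK12; sZ0; sX0];
 [:: sX0; sCX01; sCZ12; sK12; sCCX12; sK12; sZ2; sX2];
 [:: sX0; sCX02; sCZ12; sK12; sCCX12; sK12; sZ2; sX2];
 [:: sX0; sCX02; sK01; sCX21; sCCX01; sK01; sZ1; sX1];
 [:: sX0; sCX12; sCX01; sCZ12; sK01; sCCX01; sK01; sX1];
 [:: sX0; sCX12; sZ2; sK01; sCX12; sCX01; sCCX12; sK12];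
 [:: sX0; sCZ01; sCZ12; sK01; sCCX01; sK01; sX2; sX1];
 [:: sX0; sCZ02; sCZ12; sK01; sCCX01; sK01; sX2; sX1];
 [:: sX0; sCZ12; sK12; sCX01; sCCX12; sK12; sZ2; sX2];
 [:: sX0; sK01; sZ1; sCX21; sX1; sCCX01; sK01; sX1];
 [:: sX0; sZ2; sCX02; sK01; sCX21; sCCX01; sK01; sX2];
 [:: sX1; sCX12; sK12; sCX20; sCCX01; sK01; sX2; sX0];
 [:: sX1; sCX20; sK12; sCX01; sCCX12; sK12; sZ2; sX2];
 [:: sX1; sCZ01; sK01; sCX02; sCCX12; sK12; sZ2; sX2];
 [:: sX1; sCZ12; sK12; sCX20; sCCX01; sK01; sZ0; sX0];
 [:: sX1; sCZ12; sK12; sX0; sZ0; sCCX12; sK12; sX0];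
 [:: sX1; sK12; sZ2; sCX02; sX2; sCCX12; sK12; sX2];
 [:: sX1; sZ2; sX2; sCX20; sK12; sCX01; sCCX12; sK12];
 [:: sX2; sCX20; sK12; sCX01; sCCX12; sK12; sZ1; sX1];
 [:: sX2; sCX21; sCZ01; sK01; sCCX01; sK01; sZ0; sX0];
 [:: sX2; sCZ12; sK12; sX0; sZ0; sCCX12; sK12; sX0];
 [:: sX2; sK12; sZ1; sCX01; sX1; sCCX12; sK12; sX1];
 [:: sX2; sX1; sCZ01; sCZ12; sK12; sCCX12; sK12; sX0];
 [:: sX2; sZ2; sCX02; sK01; sCX21; sCCX01; sK01; sX2];
 [:: sX2; sZ2; sX0; sCX02; sK01; sCX21; sCCX01; sK01];
 [:: sZ0; sCX12; sK01; sZ0; sCX10; sCX21; sCCX01; sK01];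
 [:: sZ0; sCX20; sK12; sCX01; sCCX12; sK12; sZ1; sX1];
 [:: sZ0; sX1; sX0; sCX02; sK01; sCX21; sCCX01; sK01];
 [:: sZ0; sZ2; sX2; sCX20; sK12; sCX01; sCCX12; sK12];
 [:: sZ2; sCX02; sCX01; sCZ12; sK12; sCCX12; sK12; sX0];
 [:: sZ2; sCX02; sCZ12; sK12; sCCX12; sK12; sZ2; sX2];
 [:: sZ2; sCZ01; sK01; sZ0; sCX10; sCX21; sCCX01; sK01];
 [:: sZ2; sK12; sZ1; sCX01; sX1; sCCX12; sK12; sX1];
 [:: sCX02; sCZ02; sCZ12; sK12; sCCX12; sK12; sX2; sZ2; sX2];
 [:: sCX10; sK12; sZ0; sCX12; sCX01; sCCX12; sK12; sZ1; sX1];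
 [:: sCX20; sCX12; sCZ02; sK12; sX0; sZ0; sCCX12; sK12; sX0];
 [:: sCX20; sK12; sCX10; sZ1; sCX21; sX1; sCCX01; sK01; sX1];
 [:: sCX21; sZ0; sZ2; sX2; sCX20; sK12; sCX01; sCCX12; sK12];
 [:: sCZ12; sK12; sCX20; sX0; sZ0; sCX10; sCCX02; sCX12; sK01];
 [:: sCZ12; sK12; sCX20; sZ1; sCX21; sX0; sCCX01; sK01; sX0];
 [:: sS01; sCZ12; sK12; sX0; sZ0; sCX10; sCX21; sCCX01; sK01]].
Definition level2 : seq (seq sym) := [:: [::];
 [:: sS12; sCX20; sX0; sCZ01; sX0; sCX20; sS12];
 [:: sCX21; sX2; sX0; sCCX01; sX0; sX2; sCX21];
 [:: sCX21; sX0; sCZ01; sX0; sCX21; sCX21; sX2; sX0; sCCX01; sX0; sX2; sCX21];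
 [:: sS12; sX0; sCCX01; sX0; sS12];
 [:: sS12; sX2; sX0; sCZ01; sX0; sX2; sS12; sS12; sX0; sCCX01; sX0; sS12];
 [:: sCX20; sX2; sX1; sCCX01; sX1; sX2; sCX20];
 [:: sCX20; sX1; sCZ01; sX1; sCX20; sCX20; sX2; sX1; sCCX01; sX1; sX2; sCX20];
 [:: sS02; sX1; sCCX01; sX1; sS02];
 [:: sS02; sX2; sX1; sCZ01; sX1; sX2; sS02; sS02; sX1; sCCX01; sX1; sS02];
 [:: sCX21; sCX20; sX2; sCCX01; sX2; sCX20; sCX21];
 [:: sCX21; sCX20; sCZ01; sCX20; sCX21; sCX21; sCX20; sX2; sCCX01; sX2; sCX20; sCX21];
 [:: sS12; sCX20; sX0; sCCX01; sX0; sCX20; sS12];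
 [:: sS12; sX2; sCX20; sCZ01; sCX20; sX2; sS12; sS12; sCX20; sX0; sCCX01; sX0; sCX20; sS12]].
Definition level3 : seq (seq sym) := [:: [::];
 [:: sCX20; sX0; sCZ01; sX0; sCX20];
 [:: sX0; sCCX01; sX0];
 [:: sX2; sX0; sCZ01; sX0; sX2; sX0; sCCX01; sX0];
 [:: sS02; sCX21; sX0; sCCX01; sX0; sCX21; sS02];
 [:: sS12; sCX20; sX1; sCZ01; sX1; sCX20; sS12; sS02; sCX21; sX0; sCCX01; sX0; sCX21; sS02];
 [:: sCX10; sCX21; sCCX01; sCX21; sCX10];
 [:: sCX10; sCX21; sX2; sCZ01; sX2; sCX21; sCX10; sCX10; sCX21; sCCX01; sCX21; sCX10];
 [:: sS02; sX0; sCCX01; sX0; sS02];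
 [:: sS02; sX2; sX0; sCZ01; sX0; sX2; sS02; sS02; sX0; sCCX01; sX0; sS02];
 [:: sCX20; sX0; sCCX01; sX0; sCX20];
 [:: sX2; sCX20; sCZ01; sCX20; sX2; sCX20; sX0; sCCX01; sX0; sCX20]].
Definition level4 : seq (seq sym) := [:: [::];
 [:: sS02; sCZ01; sS02];
 [:: sCX01; sCX20; sX2; sCCX01; sX2; sCX20; sCX01];
 [:: sCX01; sCX20; sCZ01; sCX20; sCX01; sCX01; sCX20; sX2; sCCX01; sX2; sCX20; sCX01];
 [:: sS02; sCX21; sCCX01; sCX21; sS02];
 [:: sS12; sCX20; sCZ01; sCX20; sS12; sS02; sCX21; sCCX01; sCX21; sS02];
 [:: sCX20; sX2; sCCX01; sX2; sCX20];
 [:: sCX20; sCZ01; sCX20; sCX20; sX2; sCCX01; sX2; sCX20];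
 [:: sS02; sCCX01; sS02];
 [:: sS02; sX2; sCZ01; sX2; sS02; sS02; sCCX01; sS02]].
Definition level5 : seq (seq sym) := [:: [::];
 [:: sCX21; sX1; sCZ01; sX1; sCX21];
 [:: sX1; sCCX01; sX1];
 [:: sX2; sX1; sCZ01; sX1; sX2; sX1; sCCX01; sX1];
 [:: sS12; sX1; sCCX01; sX1; sS12];
 [:: sS12; sX2; sX1; sCZ01; sX1; sX2; sS12; sS12; sX1; sCCX01; sX1; sS12];
 [:: sCX21; sX1; sCCX01; sX1; sCX21];
 [:: sX2; sCX21; sCZ01; sCX21; sX2; sCX21; sX1; sCCX01; sX1; sCX21]].
Definition level6 : seq (seq sym) := [:: [::];
 [:: sS12; sCZ01; sS12];
 [:: sCX21; sX2; sCCX01; sX2; sCX21];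
 [:: sCX21; sCZ01; sCX21; sCX21; sX2; sCCX01; sX2; sCX21];
 [:: sS12; sCCX01; sS12];
 [:: sS12; sX2; sCZ01; sX2; sS12; sS12; sCCX01; sS12]].
Definition level7 : seq (seq sym) := [:: [::];
 [:: sCZ01];
 [:: sCCX01];
 [:: sX2; sCZ01; sX2; sCCX01]].


Definition lower_levels : seq (seq (seq sym)) :=
  [:: level2; level3; level4; level5; level6; level7].
Definition levels : seq (seq (seq sym)) := level1 :: lower_levels.

Lemma gens_wordP :
  all (fun s => all (mem gens) (gens_word s) && same_matrix [:: s] (gens_word s))
      syms.
Proof. vm_cast_no_check (erefl true). Qed.

Lemma levels_nil : all (fun T => [::] \in T) levels.
Proof. vm_cast_no_check (erefl true). Qed.

Lemma levels_cost : (\sum_(T <- levels) \max_(u <- T) count is_toffoli u <= 120)%N.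
Proof. rewrite unlock; vm_cast_no_check (erefl true). Qed.

Lemma level1_certified : certify 0 level1 lower_levels [seq [:: s] | s <- gens].
Proof. vm_cast_no_check (erefl true). Qed.

Lemma lower_levels_certified : certify_chain 1 lower_levels.
Proof. vm_cast_no_check (erefl true). Qed.

Lemma mem_syms s : s \in syms.
Proof. by case: s. Qed.

Lemma interp_eval R w : interp R w = eval (sem R) w.
Proof. by elim: w => [|s w IH]; rewrite /eval ?big_nil ?big_cons //= IH. Qed.

Lemma eval_gens_word R w :
  eval (sem R) (flatten (map gens_word w)) = eval (sem R) w.
Proof.
rewrite eval_flatten big_map; apply: eq_bigr => s _.
have /andP[_ /(same_matrixP R) <-] := allP gens_wordP s (mem_syms s).
by rewrite /eval big_seq1.
Qed.

Lemma gens_word_gens w : all (mem gens) (flatten (map gens_word w)).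
Proof.
apply/allP=> a /flatten_mapP[s _ as_].
by case/andP: (allP gens_wordP s (mem_syms s)) => /allP/(_ a as_).
Qed.

Theorem corollary1 (R : realType) (C : seq sym) :
  exists C' : seq sym, (toffoli_count C' <= 120)%N /\ interp R C = interp R C'.
Proof.
have stable_levels : stable (sem R) levels [seq [:: s] | s <- gens].
  apply: stable_cons (certifyP R level1_certified).
  exact/absorbing_chain_stable/(certify_chainP R lower_levels_certified).
have : in_product (sem R) levels (interp R C).
  rewrite interp_eval -eval_gens_word.
  exact: in_product_eval levels_nil stable_levels (gens_word_gens C).
case/(in_product_count is_toffoli) => C' eC' cC'.
exists C'; split; first exact: leq_trans cC' levels_cost.
by rewrite eC' interp_eval.
Qed.
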